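(* For every $C_\pi$ process $P$, every channel $m$, every prefix $\pi$, and channels $k,l$ and variables $x,y$, we have $$(\nu k)\big((\nu l)\overline{k}\langle l\rangle.m(y).[y=l]\pi.0 \;|\; k(x).P\big)\;\sim\;(\nu k)\big((\nu l)\overline{k}\langle l\rangle.m(y).0 \;|\; k(x).P\big).$$
   Context: The Confidential $\pi$-calculus $C_\pi$. There are two disjoint countable sets: ${\cal V}$ of variables (ranged over by $x,y,z,\dots$) and ${\cal C}$ of channels (ranged over by $k,l,m,n,\dots$). Let ${\cal N}={\cal V}\cup{\cal C}$, ranged over by $a,b,c,\dots$. Prefixes: $\pi ::= \overline{a}\langle k\rangle \mid a(x) \mid [a=b]\pi$. Processes: $P ::= 0 \mid \pi.P \mid P\,|\,P \mid (\nu k)P \mid\, !P$. The object of an output is always a channel, and the bound object of an input is always a variable. In $(\nu k)P$ the channel $k$ is bound, and in $a(x).P$ the variable $x$ is bound, with scope $P$. The sets $\mathrm{fn}(P)$, $\mathrm{bn}(P)$ and $\mathrm{n}(P)$ are the free, bound and all names of $P$. The set $\mathrm{fo}(P)$ consists of the free channels of $P$ that occur as objects of output prefixes in $P$. Processes are identified up to $\alpha$-conversion. Actions: $\alpha ::= \overline{k}\langle l\rangle \mid k(l) \mid (\nu l)\overline{k}\langle l\rangle \mid \tau$, where $k,l$ are channels. We have $\mathrm{fn}(\overline{k}\langle l\rangle)=\mathrm{fn}(k(l))=\{k,l\}$, $\mathrm{fn}((\nu l)\overline{k}\langle l\rangle)=\{k\}$, $\mathrm{bn}((\nu l)\overline{k}\langle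 l\rangle)=\{l\}$, all other bound-name sets are empty, $\mathrm{fn}(\tau)=\emptyset$, and $\mathrm{n}(\alpha)=\mathrm{fn}(\alpha)\cup\mathrm{bn}(\alpha)$. The labelled transition relation $\xrightarrow{\alpha}$ is the least relation closed under the following rules: - (out) $\overline{k}\langle l\rangle.P \xrightarrow{\overline{k}\langle l\rangle} P$. - (in) $k(x).P \xrightarrow{k(l)} P\{l/x\}$ for every channel $l$. - (match) If $\pi.P\xrightarrow{\alpha}P'$, then $[a=a]\pi.P\xrightarrow{\alpha}P'$. - (res) If $P\xrightarrow{\alpha}P'$ and $k\notin \mathrm{n}(\alpha)$, then $(\nu k)P\xrightarrow{\alpha}(\nu k)P'$. - (open) If $P\xrightarrow{\overline{k}\langle l\rangle}Q$ and $k\neq l$, then $(\nu l)P\xrightarrow{(\nu l)\overline{k}\langle l\rangle}Q$. - (par-l) If $P\xrightarrow{\alpha}Q$ and $\mathrm{bn}(\alpha)\cap\mathrm{fn}(R)=\emptyset$, then $P|R\xrightarrow{\alpha}Q|R$. - (comm-l) If $P\xrightarrow{\overline{k}\langle l\rangle}P'$ and $Q\xrightarrow{k(l)}Q'$, then $P|Q\xrightarrow{\tau}P'|Q'$. - (close-l) If $P\xrightarrow{(\nu l)\overline{k}\langle l\rangle}P'$, $Q\xrightarrow{k(l)}Q'$ and $l\notin\mathrm{fn}(Q)$, then $P|Q\xrightarrow{\tau}(\nu l)(P'|Q')$. - The symmetric rules (par-r), (comm-r), (close-r). - (rep-act) If $P\xrightarrow{\alpha}P'$, then $!P\xrightarrow{\alpha}P'|!P$.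 - (rep-comm) If $P\xrightarrow{\overline{k}\langle l\rangle}P'$ and $P\xrightarrow{k(l)}P''$, then $!P\xrightarrow{\tau}(P'|P'')|!P$. - (rep-close) If $P\xrightarrow{(\nu l)\overline{k}\langle l\rangle}P'$, $P\xrightarrow{k(l)}P''$ and $l\notin\mathrm{fn}(P)$, then $!P\xrightarrow{\tau}(\nu l)(P'|P'')|!P$. Strong bisimilarity $\sim$ is the largest symmetric binary relation on processes such that whenever $P\sim Q$ and $P\xrightarrow{\alpha}P'$ with $\mathrm{bn}(\alpha)\cap\mathrm{fn}(Q)=\emptyset$, there exists $Q'$ with $Q\xrightarrow{\alpha}Q'$ and $P'\sim Q'$. *)

From Stdlib Require Import Arith.

Definition var := nat.
Definition chan := nat.

Inductive name : Type :=
| NV : var -> name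
| NC : chan -> name.

Inductive prefix : Type :=
| POut : name -> chan -> prefix
| PIn : name -> var -> prefix
| PMatch : name -> name -> prefix -> prefix.

Inductive proc : Type :=
| Nil : proc
| Pre : prefix -> proc -> proc
| Par : proc -> proc -> proc
| Res : chan -> proc -> proc
| Rep : proc -> proc.

Fixpoint pbv (p : prefix) : option var :=
  match p with
  | POut _ _ => None
  | PIn _ y => Some y
  | PMatch _ _ q => pbv q
  end.

Fixpoint pchan (c : chan) (p : prefix) : Prop :=
  match p with
  | POut a k => a = NC c \/ k = c
  | PIn a _ => a = NC c
  | PMatch a b q => a = NC c \/ b = NC c \/ pchan c q
  end.

Fixpoint free_chan (c : chan) (P : proc) : Prop :=
  match P with
  | Nil => False
  | Pre p Q => pchan c p \/ free_chan c Q
  | Par Q R => free_chan c Q \/ free_chan c R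
  | Res k Q => k <> c /\ free_chan c Q
  | Rep Q => free_chan c Q
  end.

Fixpoint chan_bound (c : chan) (P : proc) : Prop :=
  match P with
  | Nil => False
  | Pre _ Q => chan_bound c Q
  | Par Q R => chan_bound c Q \/ chan_bound c R
  | Res k Q => k = c \/ chan_bound c Q
  | Rep Q => chan_bound c Q
  end.

Fixpoint occurs_c (c : chan) (P : proc) : Prop :=
  match P with
  | Nil => False
  | Pre p Q => pchan c p \/ occurs_c c Q
  | Par Q R => occurs_c c Q \/ occurs_c c R
  | Res k Q => k = c \/ occurs_c c Q
  | Rep Q => occurs_c c Q
  end.

Fixpoint pvar (x : var) (p : prefix) : Prop :=
  match p with
  | POut a _ => a = NV x
  | PIn a y => a = NV x \/ y = x
  | PMatch a b q => a = NV x \/ b = NV x \/ pvar x q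
  end.

Fixpoint occurs_v (x : var) (P : proc) : Prop :=
  match P with
  | Nil => False
  | Pre p Q => pvar x p \/ occurs_v x Q
  | Par Q R => occurs_v x Q \/ occurs_v x R
  | Res _ Q => occurs_v x Q
  | Rep Q => occurs_v x Q
  end.

(* ---------- naive total renamings (used only for alpha-conversion,
   always with a completely fresh target name) ---------- *)
Definition ren_c_chan (k k' c : chan) : chan := if Nat.eqb c k then k' else c.

Definition ren_c_name (k k' : chan) (a : name) : name :=
  match a with
  | NC c => NC (ren_c_chan k k' c)
  | NV y => NV y
  end.

Fixpoint ren_c_pref (k k' : chan) (p : prefix) : prefix :=
  match p with
  | POut a c => POut (ren_c_name k k' a) (ren_c_chan k k' c)
  | PIn a y => PIn (ren_c_name k k' a) y
  | PMatch a b q => PMatch (ren_c_name k k' a) (ren_c_name k k' b) (ren_c_pref k k' q)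
  end.

Fixpoint ren_c (k k' : chan) (P : proc) : proc :=
  match P with
  | Nil => Nil
  | Pre p Q => Pre (ren_c_pref k k' p) (ren_c k k' Q)
  | Par Q R => Par (ren_c k k' Q) (ren_c k k' R)
  | Res c Q => Res (ren_c_chan k k' c) (ren_c k k' Q)
  | Rep Q => Rep (ren_c k k' Q)
  end.

Definition ren_v_var (x x' y : var) : var := if Nat.eqb y x then x' else y.

Definition ren_v_name (x x' : var) (a : name) : name :=
  match a with
  | NV y => NV (ren_v_var x x' y)
  | NC c => NC c
  end.

Fixpoint ren_v_pref (x x' : var) (p : prefix) : prefix :=
  match p with
  | POut a c => POut (ren_v_name x x' a) c
  | PIn a y => PIn (ren_v_name x x' a) (ren_v_var x x' y)
  | PMatch a b q => PMatch (ren_v_name x x' a) (ren_v_name x x' b) (ren_v_pref x x' q)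
  end.

Fixpoint ren_v (x x' : var) (P : proc) : proc :=
  match P with
  | Nil => Nil
  | Pre p Q => Pre (ren_v_pref x x' p) (ren_v x x' Q)
  | Par Q R => Par (ren_v x x' Q) (ren_v x x' R)
  | Res c Q => Res c (ren_v x x' Q)
  | Rep Q => Rep (ren_v x x' Q)
  end.

Fixpoint set_pbv (p : prefix) (x' : var) : prefix :=
  match p with
  | POut a c => POut a c
  | PIn a _ => PIn a x'
  | PMatch a b q => PMatch a b (set_pbv q x')
  end.

Inductive alpha : proc -> proc -> Prop :=
| al_refl : forall P, alpha P P
| al_sym : forall P Q, alpha P Q -> alpha Q P
| al_trans : forall P Q R, alpha P Q -> alpha Q R -> alpha P R
| al_pre : forall p P Q, alpha P Q -> alpha (Pre p P) (Pre p Q)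
| al_par : forall P P' Q Q', alpha P P' -> alpha Q Q' -> alpha (Par P Q) (Par P' Q')
| al_res : forall k P Q, alpha P Q -> alpha (Res k P) (Res k Q)
| al_rep : forall P Q, alpha P Q -> alpha (Rep P) (Rep Q)
| al_res_ren : forall k k' P, ~ occurs_c k' P ->
    alpha (Res k P) (Res k' (ren_c k k' P))
| al_in_ren : forall p x x' P, pbv p = Some x -> ~ occurs_v x' P ->
    alpha (Pre p P) (Pre (set_pbv p x') (ren_v x x' P)).

(* ---------- substitution P{l/x} of a channel for a variable ----------
   Replaces the free occurrences of x; it is capture-avoiding whenever l
   is not bound by a restriction in P (which is imposed in rule (in);
   together with the alpha rule this yields P{l/x} up to alpha). *)
Definition subst_name (x : var) (l : chan) (a : name) : name :=
  match a with
  | NV y => if Nat.eqb y x then NC l else NV y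
  | NC c => NC c
  end.

Fixpoint subst_pref (x : var) (l : chan) (p : prefix) : prefix :=
  match p with
  | POut a c => POut (subst_name x l a) c
  | PIn a y => PIn (subst_name x l a) y
  | PMatch a b q => PMatch (subst_name x l a) (subst_name x l b) (subst_pref x l q)
  end.

Fixpoint subst (P : proc) (x : var) (l : chan) : proc :=
  match P with
  | Nil => Nil
  | Pre p Q =>
      Pre (subst_pref x l p)
          (match pbv p with
           | Some y => if Nat.eqb y x then Q else subst Q x l
           | None => subst Q x l
           end)
  | Par Q R => Par (subst Q x l) (subst R x l)
  | Res c Q => Res c (subst Q x l)
  | Rep Q => Rep (subst Q x l)
  end.

Inductive act : Type :=
| AOut : chan -> chan -> act
| AIn : chan -> chan -> act
| ABOut : chan -> chan -> act     (* (nu l) k<l>  : ABOut k l *)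
| ATau : act.

Definition act_names (a : act) (c : chan) : Prop :=
  match a with
  | AOut k l | AIn k l | ABOut k l => c = k \/ c = l
  | ATau => False
  end.

Definition act_bn (a : act) (c : chan) : Prop :=
  match a with
  | ABOut _ l => c = l
  | _ => False
  end.

Inductive trans : proc -> act -> proc -> Prop :=
| t_out : forall k l P, trans (Pre (POut (NC k) l) P) (AOut k l) P
| t_in : forall k x l P, ~ chan_bound l P ->
    trans (Pre (PIn (NC k) x) P) (AIn k l) (subst P x l)
| t_match : forall a p P al P', trans (Pre p P) al P' ->
    trans (Pre (PMatch a a p) P) al P'
| t_res : forall k P al P', trans P al P' -> ~ act_names al k ->
    trans (Res k P) al (Res k P')
| t_open : forall k l P Q, trans P (AOut k l) Q -> k <> l ->
    trans (Res l P) (ABOut k l) Q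
| t_parl : forall P Q R al, trans P al Q -> (forall c, act_bn al c -> ~ free_chan c R) ->
    trans (Par P R) al (Par Q R)
| t_parr : forall P Q R al, trans P al Q -> (forall c, act_bn al c -> ~ free_chan c R) ->
    trans (Par R P) al (Par R Q)
| t_comml : forall P P' Q Q' k l, trans P (AOut k l) P' -> trans Q (AIn k l) Q' ->
    trans (Par P Q) ATau (Par P' Q')
| t_commr : forall P P' Q Q' k l, trans P (AIn k l) P' -> trans Q (AOut k l) Q' ->
    trans (Par P Q) ATau (Par P' Q')
| t_closel : forall P P' Q Q' k l, trans P (ABOut k l) P' -> trans Q (AIn k l) Q' ->
    ~ free_chan l Q -> trans (Par P Q) ATau (Res l (Par P' Q'))
| t_closer : forall P P' Q Q' k l, trans P (AIn k l) P' -> trans Q (ABOut k l) Q' ->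
    ~ free_chan l P -> trans (Par P Q) ATau (Res l (Par P' Q'))
| t_rep_act : forall P P' al, trans P al P' -> trans (Rep P) al (Par P' (Rep P))
| t_rep_comm : forall P P' P'' k l, trans P (AOut k l) P' -> trans P (AIn k l) P'' ->
    trans (Rep P) ATau (Par (Par P' P'') (Rep P))
| t_rep_close : forall P P' P'' k l, trans P (ABOut k l) P' -> trans P (AIn k l) P'' ->
    ~ free_chan l P -> trans (Rep P) ATau (Par (Res l (Par P' P'')) (Rep P))
(* processes are identified up to alpha-conversion *)
| t_alpha : forall P P' al Q, alpha P P' -> trans P' al Q -> trans P al Q.

Definition is_bisim (R : proc -> proc -> Prop) : Prop :=
  (forall P Q, R P Q -> R Q P) /\
  (forall P Q, R P Q -> forall al P', trans P al P' ->
     (forall c, act_bn al c -> ~ free_chan c Q) ->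
     exists Q', trans Q al Q' /\ R P' Q').

Definition bisim (P Q : proc) : Prop := exists R, is_bisim R /\ R P Q.

From Stdlib Require Import Arith Lia List.
Import ListNotations.

(* In C_pi only channels are ever output, never received variables.  The private
   channel l, once handed to k(x).P, can therefore never be sent back along m, so the
   match [y=l] never succeeds and m(y).[y=l]pi.0 behaves like m(y).0. *)

Definition mapc_name (f : chan -> chan) (a : name) : name :=
  match a with NC c => NC (f c) | NV y => NV y end.

Fixpoint mapc_pref (f : chan -> chan) (p : prefix) : prefix :=
  match p with
  | POut a c => POut (mapc_name f a) (f c)
  | PIn a y => PIn (mapc_name f a) y
  | PMatch a b q => PMatch (mapc_name f a) (mapc_name f b) (mapc_pref f q)
  end.

Fixpoint mapc (f : chan -> chan) (P : proc) : proc :=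
  match P with
  | Nil => Nil
  | Pre p Q => Pre (mapc_pref f p) (mapc f Q)
  | Par Q R => Par (mapc f Q) (mapc f R)
  | Res c Q => Res (f c) (mapc f Q)
  | Rep Q => Rep (mapc f Q)
  end.

Definition mapv_name (g : var -> var) (a : name) : name :=
  match a with NV y => NV (g y) | NC c => NC c end.

Fixpoint mapv_pref (g : var -> var) (p : prefix) : prefix :=
  match p with
  | POut a c => POut (mapv_name g a) c
  | PIn a y => PIn (mapv_name g a) (g y)
  | PMatch a b q => PMatch (mapv_name g a) (mapv_name g b) (mapv_pref g q)
  end.

Fixpoint mapv (g : var -> var) (P : proc) : proc :=
  match P with
  | Nil => Nil
  | Pre p Q => Pre (mapv_pref g p) (mapv g Q)
  | Par Q R => Par (mapv g Q) (mapv g R)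
  | Res c Q => Res c (mapv g Q)
  | Rep Q => Rep (mapv g Q)
  end.

Definition mapa (f : chan -> chan) (a : act) : act :=
  match a with
  | AOut k l => AOut (f k) (f l)
  | AIn k l => AIn (f k) (f l)
  | ABOut k l => ABOut (f k) (f l)
  | ATau => ATau
  end.

Definition swap (a b c : nat) : nat :=
  if Nat.eqb c a then b else if Nat.eqb c b then a else c.

Definition inj (f : nat -> nat) := forall a b, f a = f b -> a = b.

(* Case analysis on the equality tests hidden in [swap]. *)
Ltac destruct_eqb := repeat (match goal with |- context [Nat.eqb ?x ?y] => is_var x;
    destruct (Nat.eqb_spec x y) end); try lia.

Lemma swap_l a b : swap a b a = b.
Proof. unfold swap. rewrite Nat.eqb_refl. auto. Qed.

Lemma swap_r a b : swap a b b = a.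
Proof. unfold swap. destruct (Nat.eqb_spec b a); subst; auto. rewrite Nat.eqb_refl; auto. Qed.

Lemma swap_o a b c : c <> a -> c <> b -> swap a b c = c.
Proof. intros. unfold swap. destruct (Nat.eqb_spec c a); try lia. destruct (Nat.eqb_spec c b); lia. Qed.

Lemma swap_same a c : swap a a c = c.
Proof. unfold swap. destruct (Nat.eqb_spec c a); subst; auto. Qed.

Lemma swap_inv a b c : swap a b (swap a b c) = c.
Proof. unfold swap. destruct_eqb. Qed.

Lemma swap_inj a b : inj (swap a b).
Proof. intros x y H. rewrite <- (swap_inv a b x), <- (swap_inv a b y), H. auto. Qed.

Lemma swap_sym a b c : swap a b c = swap b a c.
Proof. unfold swap. destruct_eqb. Qed.

(* Rewrites [swap a b c] when c is one of a, b or provably distinct from both. *)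
Ltac simpl_swap := repeat match goal with
 | |- context [swap ?a ?b ?c] => match c with context [swap _ _ _] => fail 1 | _ =>
      first [ rewrite (swap_l a b) | rewrite (swap_r a b) | rewrite (swap_o a b c) by (auto; lia) ] end
 end.

Lemma mapc_name_comp f g a : mapc_name f (mapc_name g a) = mapc_name (fun c => f (g c)) a.
Proof. destruct a; auto. Qed.

Lemma mapc_pref_comp f g p : mapc_pref f (mapc_pref g p) = mapc_pref (fun c => f (g c)) p.
Proof. induction p; simpl; rewrite ?mapc_name_comp; congruence. Qed.

Lemma mapc_comp f g P : mapc f (mapc g P) = mapc (fun c => f (g c)) P.
Proof. induction P; simpl; rewrite ?mapc_pref_comp; congruence. Qed.

Lemma mapc_name_ext f g a : (forall c, a = NC c -> f c = g c) -> mapc_name f a = mapc_name g a.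
Proof. destruct a; simpl; intros H; auto; rewrite H; auto. Qed.

Lemma mapc_pref_ext f g p : (forall c, pchan c p -> f c = g c) -> mapc_pref f p = mapc_pref g p.
Proof. induction p; simpl; intros H; f_equal; try apply mapc_name_ext; intros; try apply IHp;
    intros; apply H; auto.
Qed.

Lemma mapc_ext f g P : (forall c, occurs_c c P -> f c = g c) -> mapc f P = mapc g P.
Proof. induction P; simpl; intros H; try reflexivity; f_equal; try apply mapc_pref_ext;
    try apply IHP; try apply IHP1; try apply IHP2; intros; apply H; auto.
Qed.

Lemma mapc_pref_id f p : (forall c, pchan c p -> f c = c) -> mapc_pref f p = p.
Proof. intros H. transitivity (mapc_pref (fun c => c) p). apply mapc_pref_ext; auto.
  clear H; induction p; simpl; try destruct n; try destruct n0; simpl; congruence. Qed.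

Lemma mapc_id f P : (forall c, occurs_c c P -> f c = c) -> mapc f P = P.
Proof. intros H. transitivity (mapc (fun c => c) P). apply mapc_ext; auto.
  clear H; induction P; simpl; try congruence.
  - f_equal; auto. induction p; simpl; try destruct n; try destruct n0; simpl; congruence.
Qed.

Lemma mapc_swap_sym a b P : mapc (swap a b) P = mapc (swap b a) P.
Proof. apply mapc_ext; intros; apply swap_sym. Qed.

Lemma mapv_name_comp f g a : mapv_name f (mapv_name g a) = mapv_name (fun c => f (g c)) a.
Proof. destruct a; auto. Qed.

Lemma mapv_pref_comp f g p : mapv_pref f (mapv_pref g p) = mapv_pref (fun c => f (g c)) p.
Proof. induction p; simpl; rewrite ?mapv_name_comp; congruence. Qed.

Lemma mapv_comp f g P : mapv f (mapv g P) = mapv (fun c => f (g c)) P.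
Proof. induction P; simpl; rewrite ?mapv_pref_comp; congruence. Qed.

Lemma mapv_name_ext f g a : (forall c, a = NV c -> f c = g c) -> mapv_name f a = mapv_name g a.
Proof. destruct a; simpl; intros H; auto; rewrite H; auto. Qed.

Lemma mapv_pref_ext f g p : (forall c, pvar c p -> f c = g c) -> mapv_pref f p = mapv_pref g p.
Proof. induction p; simpl; intros H; f_equal; try apply mapv_name_ext; intros; try apply IHp;
    intros; apply H; auto.
Qed.

Lemma mapv_ext f g P : (forall c, occurs_v c P -> f c = g c) -> mapv f P = mapv g P.
Proof. induction P; simpl; intros H; try reflexivity; f_equal; try apply mapv_pref_ext;
    try apply IHP; try apply IHP1; try apply IHP2; intros; apply H; auto.
Qed.

Lemma mapc_mapv f g P : mapc f (mapv g P) = mapv g (mapc f P).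
Proof. induction P; simpl; try congruence. f_equal; auto.
  induction p; simpl; try destruct n; try destruct n0; simpl; congruence. Qed.

Lemma mapv_nil g P : mapv g P = Nil -> P = Nil.
Proof. destruct P; simpl; congruence. Qed.

Lemma ren_c_mapc k k' P : ren_c k k' P = mapc (ren_c_chan k k') P.
Proof. induction P; simpl; try congruence. f_equal; auto.
  induction p; simpl; try destruct n; try destruct n0; simpl; congruence. Qed.

Lemma ren_v_mapv x x' P : ren_v x x' P = mapv (ren_v_var x x') P.
Proof. induction P; simpl; try congruence. f_equal; auto.
  induction p; simpl; try destruct n; try destruct n0; simpl; congruence. Qed.

Lemma ren_c_swap k k' P : ~ occurs_c k' P -> ren_c k k' P = mapc (swap k k') P.
Proof. intros H. rewrite ren_c_mapc. apply mapc_ext. intros c Hc.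
  unfold ren_c_chan, swap. destruct (Nat.eqb_spec c k); auto.
  destruct (Nat.eqb_spec c k'); subst; tauto. Qed.

Lemma ren_v_swap x x' P : ~ occurs_v x' P -> ren_v x x' P = mapv (swap x x') P.
Proof. intros H. rewrite ren_v_mapv. apply mapv_ext. intros c Hc.
  unfold ren_v_var, swap. destruct (Nat.eqb_spec c x); auto.
  destruct (Nat.eqb_spec c x'); subst; tauto. Qed.

Fixpoint size (P : proc) : nat :=
  match P with
  | Nil => 1
  | Pre _ Q => S (size Q)
  | Par Q R => S (size Q + size R)
  | Res _ Q => S (size Q)
  | Rep Q => S (size Q)
  end.

Lemma size_mapc f P : size (mapc f P) = size P.
Proof. induction P; simpl; auto. Qed.

Lemma size_mapv f P : size (mapv f P) = size P.
Proof. induction P; simpl; auto. Qed.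

Lemma size_pos P : 1 <= size P.
Proof. destruct P; simpl; lia. Qed.

Fixpoint pfo (c : chan) (p : prefix) : Prop :=
  match p with POut _ d => d = c | PIn _ _ => False | PMatch _ _ q => pfo c q end.

Fixpoint fo (c : chan) (P : proc) : Prop :=
  match P with
  | Nil => False
  | Pre p Q => pfo c p \/ fo c Q
  | Par Q R => fo c Q \/ fo c R
  | Res k Q => k <> c /\ fo c Q
  | Rep Q => fo c Q
  end.

Fixpoint pfv (x : var) (p : prefix) : Prop :=
  match p with
  | POut a _ => a = NV x
  | PIn a _ => a = NV x
  | PMatch a b q => a = NV x \/ b = NV x \/ pfv x q
  end.

Fixpoint fv (x : var) (P : proc) : Prop :=
  match P with
  | Nil => False
  | Pre p Q => pfv x p \/ (fv x Q /\ pbv p <> Some x)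
  | Par Q R => fv x Q \/ fv x R
  | Res _ Q => fv x Q
  | Rep Q => fv x Q
  end.

Lemma pfo_pchan c p : pfo c p -> pchan c p.
Proof. induction p; simpl; intuition. Qed.

Lemma fo_free c P : fo c P -> free_chan c P.
Proof. induction P; simpl; intuition; auto using pfo_pchan. Qed.

Lemma free_occ c P : free_chan c P -> occurs_c c P.
Proof. induction P; simpl; intuition. Qed.

Lemma cb_occ c P : chan_bound c P -> occurs_c c P.
Proof. induction P; simpl; intuition. Qed.

Lemma pfv_pvar x p : pfv x p -> pvar x p.
Proof. induction p; simpl; intuition. Qed.

Lemma fv_occ x P : fv x P -> occurs_v x P.
Proof. induction P; simpl; intuition; auto using pfv_pvar. Qed.

Lemma set_pbv_id p x : pbv p = Some x -> set_pbv p x = p.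
Proof. induction p; simpl; intros H; try discriminate; try congruence. rewrite IHp; auto. Qed.

Lemma set_pbv_set p x y : set_pbv (set_pbv p x) y = set_pbv p y.
Proof. induction p; simpl; congruence. Qed.

Lemma pbv_set p x z : pbv p = Some z -> pbv (set_pbv p x) = Some x.
Proof. induction p; simpl; intros; try discriminate; auto. Qed.

Lemma pchan_set c p x : pchan c (set_pbv p x) <-> pchan c p.
Proof. induction p; simpl; tauto. Qed.

Lemma pfo_set c p x : pfo c (set_pbv p x) <-> pfo c p.
Proof. induction p; simpl; tauto. Qed.

Lemma pfv_set z p x : pfv z (set_pbv p x) <-> pfv z p.
Proof. induction p; simpl; tauto. Qed.

Section ChannelRenaming.
Variable f : chan -> chan.
Hypothesis Hf : inj f.

Lemma mapc_name_NC c a : mapc_name f a = NC (f c) <-> a = NC c.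
Proof. destruct a as [y|c0]; simpl; split; intro H; try discriminate.
  - inversion H as [H1]. apply Hf in H1. subst. reflexivity.
  - inversion H; subst; reflexivity. Qed.

Lemma pchan_mapc c p : pchan (f c) (mapc_pref f p) <-> pchan c p.
Proof. induction p; simpl; rewrite ?mapc_name_NC; try rewrite IHp; try tauto.
  assert (f c0 = f c <-> c0 = c) by (split; intro; subst; auto). tauto. Qed.

Lemma pfo_mapc c p : pfo (f c) (mapc_pref f p) <-> pfo c p.
Proof. induction p; simpl; try tauto. split; intro H; subst; auto. Qed.

Lemma free_mapc c P : free_chan (f c) (mapc f P) <-> free_chan c P.
Proof. induction P; simpl; rewrite ?pchan_mapc; try tauto.
  rewrite IHP. split; intros [H1 H2]; split; auto; intro; subst; auto. Qed.

Lemma occ_mapc c P : occurs_c (f c) (mapc f P) <-> occurs_c c P.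
Proof. induction P; simpl; rewrite ?pchan_mapc; try tauto.
  rewrite IHP. split; intros [H|H]; auto; left; subst; auto. Qed.

Lemma cb_mapc c P : chan_bound (f c) (mapc f P) <-> chan_bound c P.
Proof. induction P; simpl; try tauto.
  rewrite IHP. split; intros [H|H]; auto; left; subst; auto. Qed.

Lemma fo_mapc c P : fo (f c) (mapc f P) <-> fo c P.
Proof. induction P; simpl; rewrite ?pfo_mapc; try tauto.
  rewrite IHP. split; intros [H1 H2]; split; auto; intro; subst; auto. Qed.
End ChannelRenaming.

Lemma pvar_mapc f x p : pvar x (mapc_pref f p) <-> pvar x p.
Proof. induction p; simpl; try destruct n; try destruct n0; simpl; split; intuition;
    try discriminate; congruence. Qed.

Lemma occv_mapc f x P : occurs_v x (mapc f P) <-> occurs_v x P.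
Proof. induction P; simpl; rewrite ?pvar_mapc; tauto. Qed.

Lemma pfv_mapc f x p : pfv x (mapc_pref f p) <-> pfv x p.
Proof. induction p; simpl; try destruct n; try destruct n0; simpl; split; intuition;
    try discriminate; congruence. Qed.

Lemma pbv_mapc f p : pbv (mapc_pref f p) = pbv p.
Proof. induction p; simpl; auto. Qed.

Lemma fv_mapc f x P : fv x (mapc f P) <-> fv x P.
Proof. induction P; simpl; rewrite ?pfv_mapc, ?pbv_mapc; tauto. Qed.

Lemma set_pbv_mapc f p x : set_pbv (mapc_pref f p) x = mapc_pref f (set_pbv p x).
Proof. induction p; simpl; congruence. Qed.

Lemma mapc_subst f P x c : mapc f (subst P x c) = subst (mapc f P) x (f c).
Proof. induction P; simpl; try congruence.
  rewrite pbv_mapc. f_equal.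
  - induction p; simpl; try destruct n; try destruct n0; simpl;
    repeat (match goal with |- context [Nat.eqb ?a ?b] => destruct (Nat.eqb a b) end); simpl; congruence.
  - destruct (pbv p); try destruct (Nat.eqb v x); auto.
Qed.

Lemma pchan_mapv g c p : pchan c (mapv_pref g p) <-> pchan c p.
Proof. induction p; simpl; try destruct n; try destruct n0; simpl; split; intuition;
    try discriminate; congruence. Qed.

Lemma free_mapv g c P : free_chan c (mapv g P) <-> free_chan c P.
Proof. induction P; simpl; rewrite ?pchan_mapv; tauto. Qed.

Lemma occ_mapv g c P : occurs_c c (mapv g P) <-> occurs_c c P.
Proof. induction P; simpl; rewrite ?pchan_mapv; tauto. Qed.

Lemma cb_mapv g c P : chan_bound c (mapv g P) <-> chan_bound c P.
Proof. induction P; simpl; tauto. Qed.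

Lemma pfo_mapv g c p : pfo c (mapv_pref g p) <-> pfo c p.
Proof. induction p; simpl; tauto. Qed.

Lemma fo_mapv g c P : fo c (mapv g P) <-> fo c P.
Proof. induction P; simpl; rewrite ?pfo_mapv; tauto. Qed.

Lemma pbv_mapv g p : pbv (mapv_pref g p) = option_map g (pbv p).
Proof. induction p; simpl; auto. Qed.

Section VariableRenaming.
Variable g : var -> var.
Hypothesis Hg : inj g.

Lemma mapv_name_NV x a : mapv_name g a = NV (g x) <-> a = NV x.
Proof. destruct a as [y|c0]; simpl; split; intro H; try discriminate.
  - inversion H as [H1]. apply Hg in H1. subst. reflexivity.
  - inversion H; subst; reflexivity. Qed.

Lemma pvar_mapv x p : pvar (g x) (mapv_pref g p) <-> pvar x p.
Proof. induction p; simpl; rewrite ?mapv_name_NV; try tauto.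
  split; intros [H|H]; auto; right; try apply Hg; auto; subst; auto. Qed.

Lemma occv_mapv x P : occurs_v (g x) (mapv g P) <-> occurs_v x P.
Proof. induction P; simpl; rewrite ?pvar_mapv; tauto. Qed.

Lemma pfv_mapv x p : pfv (g x) (mapv_pref g p) <-> pfv x p.
Proof. induction p; simpl; rewrite ?mapv_name_NV; tauto. Qed.

Lemma fv_mapv x P : fv (g x) (mapv g P) <-> fv x P.
Proof. induction P; simpl; rewrite ?pfv_mapv, ?pbv_mapv; try tauto.
  rewrite IHP. destruct (pbv p) as [v|]; simpl;
  [| assert (None = Some (g x) <-> @None var = Some x) by (split; discriminate); tauto].
  assert (E: Some (g v) = Some (g x) <-> Some v = Some x).
  { split; intro Hc; inversion Hc as [H1]; [apply Hg in H1|]; subst; auto. }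
  tauto.
Qed.

Lemma set_pbv_mapv p x : set_pbv (mapv_pref g p) (g x) = mapv_pref g (set_pbv p x).
Proof. induction p; simpl; congruence. Qed.

Lemma mapv_subst_name a x c : mapv_name g (subst_name x c a) = subst_name (g x) c (mapv_name g a).
Proof. destruct a as [v|]; simpl; auto.
  destruct (Nat.eqb_spec v x); destruct (Nat.eqb_spec (g v) (g x)); subst; simpl; auto.
  - congruence.
  - apply Hg in e; congruence. Qed.

Lemma mapv_subst_pref p x c : mapv_pref g (subst_pref x c p) = subst_pref (g x) c (mapv_pref g p).
Proof. induction p; simpl; rewrite ?mapv_subst_name; congruence. Qed.

Lemma mapv_subst P x c : mapv g (subst P x c) = subst (mapv g P) (g x) c.
Proof. induction P; simpl; try congruence.
  rewrite pbv_mapv. f_equal.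
  - apply mapv_subst_pref.
  - destruct (pbv p); simpl; auto.
    destruct (Nat.eqb_spec v x); destruct (Nat.eqb_spec (g v) (g x)); subst; auto.
    + congruence.
    + apply Hg in e; congruence.
Qed.
End VariableRenaming.

Lemma pbv_subst x l p : pbv (subst_pref x l p) = pbv p.
Proof. induction p; simpl; auto. Qed.

Lemma set_pbv_subst x l p y : set_pbv (subst_pref x l p) y = subst_pref x l (set_pbv p y).
Proof. induction p; simpl; congruence. Qed.

Lemma pfo_subst x l c p : pfo c (subst_pref x l p) <-> pfo c p.
Proof. induction p; simpl; tauto. Qed.

Lemma fo_subst c P x l : fo c (subst P x l) <-> fo c P.
Proof. induction P; simpl; rewrite ?pfo_subst; try tauto.
  destruct (pbv p) as [v|]; [destruct (Nat.eqb v x)|]; rewrite ?IHP; tauto. Qed.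

Lemma subst_pref_notfree x l p : ~ pfv x p -> subst_pref x l p = p.
Proof. induction p; simpl; intros H; try destruct n; try destruct n0; simpl in *;
  repeat (match goal with |- context [Nat.eqb ?a ?b] => destruct (Nat.eqb_spec a b) end); subst; try tauto;
  try rewrite IHp; auto. Qed.

Lemma subst_notfree x l P : ~ fv x P -> subst P x l = P.
Proof. induction P; simpl; intros H; auto.
  - rewrite subst_pref_notfree by tauto. f_equal.
    destruct (pbv p) as [v|] eqn:E; [destruct (Nat.eqb_spec v x)|]; subst; auto;
    apply IHP; intro; apply H; right; split; auto; congruence.
  - f_equal; auto.
  - f_equal; auto.
  - f_equal; auto.
Qed.

Definition nchans (a : name) : list chan := match a with NC c => [c] | NV _ => [] end.

Definition nvars (a : name) : list var := match a with NV c => [c] | NC _ => [] end.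

Fixpoint pchans (p : prefix) : list chan :=
  match p with
  | POut a c => c :: nchans a
  | PIn a _ => nchans a
  | PMatch a b q => nchans a ++ nchans b ++ pchans q
  end.

Fixpoint pvars (p : prefix) : list var :=
  match p with
  | POut a c => nvars a
  | PIn a y => y :: nvars a
  | PMatch a b q => nvars a ++ nvars b ++ pvars q
  end.

Fixpoint chans (P : proc) : list chan :=
  match P with
  | Nil => []
  | Pre p Q => pchans p ++ chans Q
  | Par Q R => chans Q ++ chans R
  | Res k Q => k :: chans Q
  | Rep Q => chans Q
  end.

Fixpoint vars (P : proc) : list var :=
  match P with
  | Nil => []
  | Pre p Q => pvars p ++ vars Q
  | Par Q R => vars Q ++ vars R
  | Res k Q => vars Q
  | Rep Q => vars Q
  end.

Lemma nchans_in c a : a = NC c -> In c (nchans a).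
Proof. intros ->; simpl; auto. Qed.

Lemma nvars_in c a : a = NV c -> In c (nvars a).
Proof. intros ->; simpl; auto. Qed.

Lemma pchans_in c p : pchan c p -> In c (pchans p).
Proof. induction p; simpl; intros H; rewrite ?in_app_iff.
  - destruct H as [H|H]; [right; apply nchans_in; auto|left; auto].
  - apply nchans_in; auto.
  - destruct H as [H|[H|H]]; [left; apply nchans_in|right;left; apply nchans_in|right;right]; auto.
Qed.

Lemma pvars_in c p : pvar c p -> In c (pvars p).
Proof. induction p; simpl; intros H; rewrite ?in_app_iff.
  - apply nvars_in; auto.
  - destruct H as [H|H]; [right; apply nvars_in; auto|left; auto].
  - destruct H as [H|[H|H]]; [left; apply nvars_in|right;left; apply nvars_in|right;right]; auto.
Qed.

Lemma occ_chans c P : occurs_c c P -> In c (chans P).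
Proof. induction P; simpl; intros H; rewrite ?in_app_iff; try tauto.
  - destruct H as [H|H]; [left; apply pchans_in|right]; auto.
Qed.

Lemma occ_vars x P : occurs_v x P -> In x (vars P).
Proof. induction P; simpl; intros H; rewrite ?in_app_iff; try tauto.
  - destruct H as [H|H]; [left; apply pvars_in|right]; auto.
Qed.

Lemma fresh_nat (l : list nat) : exists z, ~ In z l.
Proof. exists (S (list_max l)). intro H.
  assert (F: Forall (fun k => k <= list_max l) l) by (apply list_max_le; auto).
  rewrite Forall_forall in F. apply F in H. lia. Qed.

Lemma fresh_c (Ps : list proc) (cs : list chan) : exists z, (forall P,
    In P Ps -> ~ occurs_c z P) /\ ~ In z cs.
Proof. destruct (fresh_nat (cs ++ flat_map chans Ps)) as [z Hz]. exists z. rewrite in_app_iff in Hz. split.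
  - intros P HP Hc. apply Hz. right. apply in_flat_map. exists P; split; auto. apply occ_chans; auto.
  - tauto.
Qed.

Lemma fresh_v (Ps : list proc) (cs : list var) : exists z, (forall P, In P Ps -> ~ occurs_v z P) /\ ~ In z cs.
Proof. destruct (fresh_nat (cs ++ flat_map vars Ps)) as [z Hz]. exists z. rewrite in_app_iff in Hz. split.
  - intros P HP Hc. apply Hz. right. apply in_flat_map. exists P; split; auto. apply occ_vars; auto.
  - tauto.
Qed.

Lemma alpha_mapc f P Q : inj f -> alpha P Q -> alpha (mapc f P) (mapc f Q).
Proof. intros Hf H. induction H; simpl.
  - apply al_refl.
  - apply al_sym; auto.
  - eapply al_trans; eauto.
  - apply al_pre; auto.
  - apply al_par; auto.
  - apply al_res; auto.
  - apply al_rep; auto.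
  - assert (E: mapc f (ren_c k k' P) = ren_c (f k) (f k') (mapc f P)).
    { rewrite !ren_c_mapc, !mapc_comp. apply mapc_ext. intros c _.
      unfold ren_c_chan. destruct (Nat.eqb_spec c k); destruct (Nat.eqb_spec (f c) (f k)); subst; auto.
      - congruence.
      - apply Hf in e; congruence. }
    rewrite E. apply al_res_ren. rewrite occ_mapc; auto.
  - rewrite <- set_pbv_mapc, !ren_v_mapv, mapc_mapv, <- ren_v_mapv.
    apply al_in_ren. rewrite pbv_mapc; auto. rewrite occv_mapc; auto.
Qed.

Lemma alpha_mapv g P Q : inj g -> alpha P Q -> alpha (mapv g P) (mapv g Q).
Proof. intros Hg H. induction H; simpl.
  - apply al_refl.
  - apply al_sym; auto.
  - eapply al_trans; eauto.
  - apply al_pre; auto.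
  - apply al_par; auto.
  - apply al_res; auto.
  - apply al_rep; auto.
  - rewrite ren_c_mapc, <- mapc_mapv, <- ren_c_mapc. apply al_res_ren. rewrite occ_mapv; auto.
  - assert (E: mapv g (ren_v x x' P) = ren_v (g x) (g x') (mapv g P)).
    { rewrite !ren_v_mapv, !mapv_comp. apply mapv_ext. intros c _.
      unfold ren_v_var. destruct (Nat.eqb_spec c x); destruct (Nat.eqb_spec (g c) (g x)); subst; auto.
      - congruence.
      - apply Hg in e; congruence. }
    rewrite E, <- set_pbv_mapv by auto. apply al_in_ren.
    rewrite pbv_mapv, H; auto. rewrite occv_mapv; auto.
Qed.

Lemma alpha_swap a b P Q : alpha P Q -> alpha (mapc (swap a b) P) (mapc (swap a b) Q).
Proof. apply alpha_mapc, swap_inj. Qed.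

Lemma alpha_swapv a b P Q : alpha P Q -> alpha (mapv (swap a b) P) (mapv (swap a b) Q).
Proof. apply alpha_mapv, swap_inj. Qed.

Lemma swap_mapc_inv a b P : mapc (swap a b) (mapc (swap a b) P) = P.
Proof. rewrite mapc_comp. apply mapc_id. intros; apply swap_inv. Qed.

Lemma free_swap a b c P : free_chan c (mapc (swap a b) P) <-> free_chan (swap a b c) P.
Proof. rewrite <- (free_mapc (swap a b) (swap_inj a b) (swap a b c) P), swap_inv. tauto. Qed.

Lemma occ_swap a b c P : occurs_c c (mapc (swap a b) P) <-> occurs_c (swap a b c) P.
Proof. rewrite <- (occ_mapc (swap a b) (swap_inj a b) (swap a b c) P), swap_inv. tauto. Qed.

Lemma cb_swap a b c P : chan_bound c (mapc (swap a b) P) <-> chan_bound (swap a b c) P.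
Proof. rewrite <- (cb_mapc (swap a b) (swap_inj a b) (swap a b c) P), swap_inv. tauto. Qed.

Lemma fo_swap a b c P : fo c (mapc (swap a b) P) <-> fo (swap a b c) P.
Proof. rewrite <- (fo_mapc (swap a b) (swap_inj a b) (swap a b c) P), swap_inv. tauto. Qed.

Lemma fv_swapv a b x P : fv x (mapv (swap a b) P) <-> fv (swap a b x) P.
Proof. rewrite <- (fv_mapv (swap a b) (swap_inj a b) (swap a b x) P), swap_inv. tauto. Qed.

Lemma alpha_free c P Q : alpha P Q -> (free_chan c P <-> free_chan c Q).
Proof. intros H. induction H; simpl; try tauto.
  - rewrite ren_c_swap by auto. rewrite free_swap.
    assert (~ free_chan k' P) by (intro; apply H; apply free_occ; auto).
    unfold swap; destruct (Nat.eqb_spec c k); destruct (Nat.eqb_spec c k'); subst; try tauto.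
    split; intros [A B]; split; auto.
  - rewrite pchan_set, ren_v_mapv, free_mapv. tauto.
Qed.

Lemma alpha_fo c P Q : alpha P Q -> (fo c P <-> fo c Q).
Proof. intros H. induction H; simpl; try tauto.
  - rewrite ren_c_swap by auto. rewrite fo_swap.
    assert (~ fo k' P) by (intro; apply H; apply free_occ, fo_free; auto).
    unfold swap; destruct (Nat.eqb_spec c k); destruct (Nat.eqb_spec c k'); subst; try tauto.
    split; intros [A B]; split; auto.
  - rewrite pfo_set, ren_v_mapv, fo_mapv. tauto.
Qed.

Lemma alpha_fv z P Q : alpha P Q -> (fv z P <-> fv z Q).
Proof. intros H. induction H; simpl; try tauto.
  - rewrite ren_c_mapc, fv_mapc; tauto.
  - rewrite pfv_set, ren_v_swap by auto. rewrite fv_swapv, (pbv_set p x' x) by auto. rewrite H.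
    assert (~ fv x' P) by (intro; apply H0; apply fv_occ; auto).
    unfold swap; destruct (Nat.eqb_spec z x); destruct (Nat.eqb_spec z x'); subst; try tauto.
    assert (Some x <> Some z) by congruence. assert (Some x' <> Some z) by congruence. tauto.
Qed.

(* Inversion of alpha-conversion on each process former.  Each is proved by showing
   that a suitable relation holds in both directions along the derivation. *)
Lemma alpha_nil P Q : alpha P Q -> (P = Nil <-> Q = Nil).
Proof. intros H; induction H; try tauto; split; intro E; discriminate. Qed.

Lemma alpha_nil_l Q : alpha Nil Q -> Q = Nil.
Proof. intros H; apply (alpha_nil _ _ H); auto. Qed.

Lemma alpha_nil_r Q : alpha Q Nil -> Q = Nil.
Proof. intros H; apply (alpha_nil _ _ H); auto. Qed.

Definition ParRel X Y := forall P Q, X = Par P Q -> exists P' Q', Y = Par P' Q' /\ alpha P P' /\ alpha Q Q'.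

Lemma alpha_par_gen X Y : alpha X Y -> ParRel X Y /\ ParRel Y X.
Proof. intros H; induction H; unfold ParRel in *; split; intros P0 Q0 E; try discriminate.
  - subst; eauto 6 using al_refl.
  - subst; eauto 6 using al_refl.
  - destruct IHalpha as [_ H2]; auto.
  - destruct IHalpha as [H2 _]; auto.
  - destruct IHalpha1 as [A1 B1]; destruct IHalpha2 as [A2 B2].
    destruct (A1 _ _ E) as [P1 [Q1 [E1 [H3 H4]]]]. destruct (A2 _ _ E1) as [P2 [Q2 [E2 [H5 H6]]]].
    exists P2, Q2; split; auto; split; eapply al_trans; eauto.
  - destruct IHalpha1 as [A1 B1]; destruct IHalpha2 as [A2 B2].
    destruct (B2 _ _ E) as [P1 [Q1 [E1 [H3 H4]]]]. destruct (B1 _ _ E1) as [P2 [Q2 [E2 [H5 H6]]]].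
    exists P2, Q2; split; auto; split; eapply al_trans; eauto.
  - inversion E; subst. exists P', Q'; auto.
  - inversion E; subst. exists P, Q; split; auto; split; apply al_sym; auto.
Qed.

Lemma alpha_par P Q Y : alpha (Par P Q) Y -> exists P' Q', Y = Par P' Q' /\ alpha P P' /\ alpha Q Q'.
Proof. intros H. apply (proj1 (alpha_par_gen _ _ H)); auto. Qed.

Lemma alpha_par_r X P R : alpha X (Par P R) -> exists P0 R0, X = Par P0 R0 /\ alpha P0 P /\ alpha R0 R.
Proof. intros H. apply al_sym, alpha_par in H. destruct H as [P0 [R0 [-> [H1 H2]]]].
  exists P0, R0; split; auto; split; apply al_sym; auto. Qed.

Definition RepRel X Y := forall P, X = Rep P -> exists P', Y = Rep P' /\ alpha P P'.

Lemma alpha_rep_gen X Y : alpha X Y -> RepRel X Y /\ RepRel Y X.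
Proof. intros H; induction H; unfold RepRel in *; split; intros P0 E; try discriminate.
  - subst; eauto using al_refl.
  - subst; eauto using al_refl.
  - destruct IHalpha as [_ H2]; auto.
  - destruct IHalpha as [H2 _]; auto.
  - destruct IHalpha1 as [A1 B1]; destruct IHalpha2 as [A2 B2].
    destruct (A1 _ E) as [P1 [E1 H3]]. destruct (A2 _ E1) as [P2 [E2 H5]].
    exists P2; split; auto; eapply al_trans; eauto.
  - destruct IHalpha1 as [A1 B1]; destruct IHalpha2 as [A2 B2].
    destruct (B2 _ E) as [P1 [E1 H3]]. destruct (B1 _ E1) as [P2 [E2 H5]].
    exists P2; split; auto; eapply al_trans; eauto.
  - inversion E; subst. exists Q; auto.
  - inversion E; subst. exists P; split; auto; apply al_sym; auto.
Qed.

Lemma alpha_rep P Y : alpha (Rep P) Y -> exists P', Y = Rep P' /\ alpha P P'.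
Proof. intros H. apply (proj1 (alpha_rep_gen _ _ H)); auto. Qed.

Lemma alpha_rep_r X P : alpha X (Rep P) -> exists P0, X = Rep P0 /\ alpha P0 P.
Proof. intros H. apply al_sym, alpha_rep in H. destruct H as [P0 [-> H1]].
  exists P0; split; auto; apply al_sym; auto. Qed.

Lemma alpha_res_swap k z P : ~ occurs_c z P -> alpha (Res k P) (Res z (mapc (swap k z) P)).
Proof. intros H. rewrite <- ren_c_swap by auto. apply al_res_ren; auto. Qed.

Lemma alpha_in_swap p x w P : pbv p = Some x -> ~ occurs_v w P ->
  alpha (Pre p P) (Pre (set_pbv p w) (mapv (swap x w) P)).
Proof. intros H1 H2. rewrite <- ren_v_swap by auto. apply al_in_ren; auto. Qed.

Lemma swap_comp_c z w k P : ~ occurs_c z P -> ~ occurs_c w P -> w <> k ->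
  mapc (swap z w) (mapc (swap k w) P) = mapc (swap k z) P.
Proof. intros H1 H2 H3. rewrite mapc_comp. apply mapc_ext. intros c Hc.
  assert (c <> z) by (intro; subst; tauto). assert (c <> w) by (intro; subst; tauto).
  destruct (Nat.eq_dec c k); subst; simpl_swap; auto.
Qed.

Lemma swap_comp_v z w k P : ~ occurs_v z P -> ~ occurs_v w P -> w <> k ->
  mapv (swap z w) (mapv (swap k w) P) = mapv (swap k z) P.
Proof. intros H1 H2 H3. rewrite mapv_comp. apply mapv_ext. intros c Hc.
  assert (c <> z) by (intro; subst; tauto). assert (c <> w) by (intro; subst; tauto).
  destruct (Nat.eq_dec c k); subst; simpl_swap; auto.
Qed.

Definition res_bodies_alpha (k : chan) (P : proc) (k' : chan) (P' : proc) : Prop :=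
  forall z, ~ occurs_c z P -> ~ occurs_c z P' -> alpha (mapc (swap k z) P) (mapc (swap k' z) P').

Lemma res_bodies_alpha_trans k0 P0 k1 P1 k2 P2 :
  res_bodies_alpha k0 P0 k1 P1 -> res_bodies_alpha k1 P1 k2 P2 -> res_bodies_alpha k0 P0 k2 P2.
Proof.
  intros H01 H12 z Hz0 Hz2.
  destruct (fresh_nat (z :: k0 :: k1 :: k2 :: chans P0 ++ chans P1 ++ chans P2)) as [w Hw].
  simpl in Hw; rewrite !in_app_iff in Hw.
  assert (~ occurs_c w P0) by (intro Hc; apply occ_chans in Hc; tauto).
  assert (~ occurs_c w P1) by (intro Hc; apply occ_chans in Hc; tauto).
  assert (~ occurs_c w P2) by (intro Hc; apply occ_chans in Hc; tauto).
  assert (Hw02 : alpha (mapc (swap k0 w) P0) (mapc (swap k2 w) P2)) by (eapply al_trans; eauto).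
  apply (alpha_swap z w) in Hw02. rewrite !swap_comp_c in Hw02 by (auto; intuition). auto.
Qed.

Lemma res_bodies_alpha_ren k k' P : ~ occurs_c k' P ->
  res_bodies_alpha k P k' (ren_c k k' P).
Proof.
  intros Hk' z Hz _. rewrite ren_c_swap, mapc_comp by auto.
  replace (mapc (fun c => swap k' z (swap k k' c)) P) with (mapc (swap k z) P); [apply al_refl|].
  apply mapc_ext. intros c Hc. assert (c <> z) by (intro; subst; tauto).
  assert (c <> k') by (intro; subst; tauto).
  destruct (Nat.eq_dec c k); subst; simpl_swap; auto.
Qed.

Definition ResRel X Y := forall k P, X = Res k P ->
  exists k' P', Y = Res k' P' /\ res_bodies_alpha k P k' P'.

Lemma alpha_res_gen X Y : alpha X Y -> ResRel X Y /\ ResRel Y X.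
Proof.
  intros H; induction H; unfold ResRel in *; split; intros k0 P0 E; try discriminate.
  1, 2: subst; exists k0, P0; split; auto; intros z _ _; apply al_refl.
  1, 2: destruct IHalpha as [H1 H2]; auto.
  - destruct IHalpha1 as [A1 B1]; destruct IHalpha2 as [A2 B2].
    destruct (A1 _ _ E) as [k1 [P1 [E1 H3]]]. destruct (A2 _ _ E1) as [k2 [P2 [E2 H5]]].
    exists k2, P2; split; auto. eapply res_bodies_alpha_trans; eauto.
  - destruct IHalpha1 as [A1 B1]; destruct IHalpha2 as [A2 B2].
    destruct (B2 _ _ E) as [k1 [P1 [E1 H3]]]. destruct (B1 _ _ E1) as [k2 [P2 [E2 H5]]].
    exists k2, P2; split; auto. eapply res_bodies_alpha_trans; eauto.
  - inversion E; subst. exists k0, Q; split; auto; intros z _ _; apply alpha_swap; auto.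
  - inversion E; subst. exists k0, P; split; auto; intros z _ _; apply alpha_swap, al_sym; auto.
  - inversion E; subst. exists k', (ren_c k0 k' P0); split; auto. apply res_bodies_alpha_ren; auto.
  - inversion E; subst. exists k, P; split; auto. intros z Hz1 Hz2.
    apply al_sym, res_bodies_alpha_ren; auto.
Qed.

Lemma alpha_res k P Y : alpha (Res k P) Y -> exists k' P', Y = Res k' P' /\
  forall z, ~ occurs_c z P -> ~ occurs_c z P' -> alpha (mapc (swap k z) P) (mapc (swap k' z) P').
Proof. intros H. apply (proj1 (alpha_res_gen _ _ H)); auto. Qed.

Definition in_bodies_alpha (x : var) (P : proc) (x' : var) (P' : proc) : Prop :=
  forall w, ~ occurs_v w P -> ~ occurs_v w P' -> alpha (mapv (swap x w) P) (mapv (swap x' w) P').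

Lemma in_bodies_alpha_trans x0 P0 x1 P1 x2 P2 :
  in_bodies_alpha x0 P0 x1 P1 -> in_bodies_alpha x1 P1 x2 P2 -> in_bodies_alpha x0 P0 x2 P2.
Proof.
  intros H01 H12 z Hz0 Hz2.
  destruct (fresh_nat (z :: x0 :: x1 :: x2 :: vars P0 ++ vars P1 ++ vars P2)) as [w Hw].
  simpl in Hw; rewrite !in_app_iff in Hw.
  assert (~ occurs_v w P0) by (intro Hc; apply occ_vars in Hc; tauto).
  assert (~ occurs_v w P1) by (intro Hc; apply occ_vars in Hc; tauto).
  assert (~ occurs_v w P2) by (intro Hc; apply occ_vars in Hc; tauto).
  assert (Hw02 : alpha (mapv (swap x0 w) P0) (mapv (swap x2 w) P2)) by (eapply al_trans; eauto).
  apply (alpha_swapv z w) in Hw02. rewrite !swap_comp_v in Hw02 by (auto; intuition). auto.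
Qed.

Lemma in_bodies_alpha_ren x x' P : ~ occurs_v x' P -> in_bodies_alpha x P x' (ren_v x x' P).
Proof.
  intros Hx' z Hz _. rewrite ren_v_swap, mapv_comp by auto.
  replace (mapv (fun c => swap x' z (swap x x' c)) P) with (mapv (swap x z) P); [apply al_refl|].
  apply mapv_ext. intros c Hc. assert (c <> z) by (intro; subst; tauto).
  assert (c <> x') by (intro; subst; tauto).
  destruct (Nat.eq_dec c x); subst; simpl_swap; auto.
Qed.

Definition pre_alpha (p : prefix) (P : proc) (p' : prefix) (P' : proc) : Prop :=
  (pbv p = None /\ p' = p /\ alpha P P') \/
  (exists x x', pbv p = Some x /\ p' = set_pbv p x' /\ in_bodies_alpha x P x' P').

Lemma pre_alpha_cong p P P' :
  (forall x w, pbv p = Some x -> ~ occurs_v w P -> ~ occurs_v w P' ->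
     alpha (mapv (swap x w) P) (mapv (swap x w) P')) ->
  alpha P P' -> pre_alpha p P p P'.
Proof.
  intros Hsw HP. destruct (pbv p) as [x|] eqn:Ep.
  - right; exists x, x; split; auto; split; [rewrite set_pbv_id; auto|].
    intros w Hw Hw'; apply Hsw; auto.
  - left; auto.
Qed.

Lemma pre_alpha_trans p0 P0 p1 P1 p2 P2 :
  pre_alpha p0 P0 p1 P1 -> pre_alpha p1 P1 p2 P2 -> pre_alpha p0 P0 p2 P2.
Proof.
  intros [[N0 [-> H01]]|[x [x1 [S1 [-> H01]]]]].
  - intros [[N1 [-> H12]]|[x [x1 [S1 _]]]]; [left; split; auto; split; auto; eapply al_trans;
      eauto|congruence].
  - intros [[N1 _]|[x2 [x3 [S2 [-> H12]]]]].
    + erewrite pbv_set in N1; eauto; discriminate.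
    + erewrite pbv_set in S2; eauto. inversion S2; subst x2.
      right; exists x, x3; split; auto; split; [rewrite set_pbv_set; auto|].
      eapply in_bodies_alpha_trans; eauto.
Qed.

Definition PreRel X Y := forall p P, X = Pre p P ->
  exists p' P', Y = Pre p' P' /\ pre_alpha p P p' P'.

Lemma alpha_pre_gen X Y : alpha X Y -> PreRel X Y /\ PreRel Y X.
Proof.
  intros H; induction H; unfold PreRel in *; split; intros p0 P0 E; try discriminate.
  1, 2: subst; exists p0, P0; split; auto; apply pre_alpha_cong; intros; apply al_refl.
  1, 2: destruct IHalpha as [H1 H2]; auto.
  - destruct IHalpha1 as [A1 B1]; destruct IHalpha2 as [A2 B2].
    destruct (A1 _ _ E) as [p1 [P1 [E1 H3]]]. destruct (A2 _ _ E1) as [p2 [P2 [E2 H5]]].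
    exists p2, P2; split; auto. eapply pre_alpha_trans; eauto.
  - destruct IHalpha1 as [A1 B1]; destruct IHalpha2 as [A2 B2].
    destruct (B2 _ _ E) as [p1 [P1 [E1 H3]]]. destruct (B1 _ _ E1) as [p2 [P2 [E2 H5]]].
    exists p2, P2; split; auto. eapply pre_alpha_trans; eauto.
  - inversion E; subst. exists p0, Q; split; auto.
    apply pre_alpha_cong; auto. intros; apply alpha_swapv; auto.
  - inversion E; subst. exists p0, P; split; auto.
    apply pre_alpha_cong; [intros; apply alpha_swapv|]; apply al_sym; auto.
  - inversion E; subst. exists (set_pbv p0 x'), (ren_v x x' P0); split; auto.
    right; exists x, x'; split; auto; split; auto. apply in_bodies_alpha_ren; auto.
  - inversion E; subst. exists p, P; split; auto.
    right; exists x', x; split; [eapply pbv_set; eauto|]; split; [rewrite set_pbv_set, set_pbv_id; auto|].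
    intros z Hz1 Hz2. apply al_sym, in_bodies_alpha_ren; auto.
Qed.

Lemma alpha_pre p P Y : alpha (Pre p P) Y -> exists p' P', Y = Pre p' P' /\
  ((pbv p = None /\ p' = p /\ alpha P P') \/
   (exists x x', pbv p = Some x /\ p' = set_pbv p x' /\
      forall w, ~ occurs_v w P -> ~ occurs_v w P' -> alpha (mapv (swap x w) P) (mapv (swap x' w) P'))).
Proof. intros H. apply (proj1 (alpha_pre_gen _ _ H)); auto. Qed.

Lemma alpha_pre_r X p P : alpha X (Pre p P) -> exists p' P', X = Pre p' P'.
Proof. intros H. apply al_sym, alpha_pre in H. destruct H as [p' [P' [E _]]]; eauto. Qed.

Definition PeelRel X Y := forall a b q R, X = Pre (PMatch a b q) R -> exists q' R',
  Y = Pre (PMatch a b q') R' /\ alpha (Pre q R) (Pre q' R').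

Lemma alpha_peel_gen X Y : alpha X Y -> PeelRel X Y /\ PeelRel Y X.
Proof. intros H; induction H; unfold PeelRel in *; split; intros a0 b0 q0 R0 E; try discriminate.
  - subst; exists q0, R0; split; auto; apply al_refl.
  - subst; exists q0, R0; split; auto; apply al_refl.
  - destruct IHalpha as [_ H2]; eauto.
  - destruct IHalpha as [H2 _]; eauto.
  - destruct IHalpha1 as [A1 B1]; destruct IHalpha2 as [A2 B2].
    destruct (A1 _ _ _ _ E) as [q1 [R1 [E1 H3]]]. destruct (A2 _ _ _ _ E1) as [q2 [R2 [E2 H5]]].
    exists q2, R2; split; auto; eapply al_trans; eauto.
  - destruct IHalpha1 as [A1 B1]; destruct IHalpha2 as [A2 B2].
    destruct (B2 _ _ _ _ E) as [q1 [R1 [E1 H3]]]. destruct (B1 _ _ _ _ E1) as [q2 [R2 [E2 H5]]].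
    exists q2, R2; split; auto; eapply al_trans; eauto.
  - inversion E; subst. exists q0, Q; split; auto; apply al_pre; auto.
  - inversion E; subst. exists q0, P; split; auto; apply al_pre, al_sym; auto.
  - inversion E; subst. simpl. exists (set_pbv q0 x'), (ren_v x x' R0); split; auto.
    apply al_in_ren; auto.
  - destruct p; simpl in E; inversion E; subst. exists p, P; split; auto.
    apply al_sym, al_in_ren; auto.
Qed.

Lemma alpha_peel a b q R Y : alpha (Pre (PMatch a b q) R) Y -> exists q' R',
  Y = Pre (PMatch a b q') R' /\ alpha (Pre q R) (Pre q' R').
Proof. intros H. apply (proj1 (alpha_peel_gen _ _ H)); auto. Qed.

(* Exchanging two channels that are not free gives an alpha-equivalent process.  When
   one of them is the binder of a restriction, that binder is first renamed to a fresh z. *)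
Lemma alpha_swap_nonfree_binder n a b P :
  (forall Q a b, size Q <= n -> ~ free_chan a Q -> ~ free_chan b Q -> alpha Q (mapc (swap a b) Q)) ->
  size P <= n -> ~ free_chan b (Res a P) -> alpha (Res a P) (mapc (swap a b) (Res a P)).
Proof.
  intros IHn Hs Hb. simpl. rewrite swap_l.
  destruct (Nat.eq_dec a b) as [<-|Hab]; [rewrite mapc_id; [apply al_refl|intros; apply swap_same]|].
  assert (Hb' : ~ free_chan b P) by (intro; apply Hb; simpl; split; auto).
  destruct (fresh_c [P] [a; b]) as [z [Hz1 Hz2]]. simpl in Hz2.
  assert (Hz : ~ occurs_c z P) by (apply Hz1; simpl; auto).
  eapply al_trans; [apply (alpha_res_swap a z); auto|].
  eapply al_trans; [|apply al_sym, (alpha_res_swap b z); rewrite occ_swap; simpl_swap; auto].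
  apply al_res. rewrite mapc_comp.
  replace (mapc (fun c => swap b z (swap a b c)) P) with (mapc (swap a b) (mapc (swap a z) P)).
  - apply IHn; [rewrite size_mapc; lia| |]; rewrite free_swap; simpl_swap; auto.
    intro Hc; apply Hz, free_occ; auto.
  - rewrite mapc_comp. apply mapc_ext. intros c Hc. assert (c <> z) by (intro; subst; tauto).
    destruct (Nat.eq_dec c a); [subst; simpl_swap; auto|].
    destruct (Nat.eq_dec c b); subst; simpl_swap; auto.
Qed.

Lemma alpha_swap_nonfree_n n : forall P a b, size P <= n -> ~ free_chan a P -> ~ free_chan b P ->
  alpha P (mapc (swap a b) P).
Proof.
  induction n; intros P a b Hs Ha Hb; [pose proof (size_pos P); lia|].
  destruct P as [|p P|P1 P2|c P|P].
  - apply al_refl.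
  - simpl in *. rewrite mapc_pref_id; [apply al_pre, IHn; auto; lia|].
    intros c Hc. apply swap_o; intro; subst; tauto.
  - simpl in *. apply al_par; apply IHn; auto; lia.
  - destruct (Nat.eq_dec c a) as [->|Hca]; [apply (alpha_swap_nonfree_binder n); auto; simpl in Hs; lia|].
    destruct (Nat.eq_dec c b) as [->|Hcb].
    + rewrite mapc_swap_sym. apply (alpha_swap_nonfree_binder n); auto. simpl in Hs; lia.
    + simpl in *. rewrite swap_o by auto. apply al_res, IHn; try lia; intro; [apply Ha|apply Hb]; split; auto.
  - simpl in *. apply al_rep, IHn; auto; lia.
Qed.

Lemma alpha_swap_nonfree P a b : ~ free_chan a P -> ~ free_chan b P -> alpha P (mapc (swap a b) P).
Proof. intros; eapply alpha_swap_nonfree_n; eauto. Qed.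

(* Substitution respects alpha-conversion, provided the substituted channel is not
   captured on either side; this is what makes rule (in) well-defined up to alpha. *)
Lemma subst_swap_name x u c a : a <> NV u ->
  subst_name u c (mapv_name (swap x u) a) = subst_name x c a.
Proof. destruct a as [z|]; simpl; intros H; auto.
  assert (z <> u) by congruence.
  destruct (Nat.eq_dec z x).
  - subst. rewrite swap_l, !Nat.eqb_refl; auto.
  - rewrite swap_o by auto. destruct (Nat.eqb_spec z u); destruct (Nat.eqb_spec z x); try lia; auto.
Qed.

Lemma subst_swap_pref_none x u c p : pbv p = None -> ~ pvar u p ->
  subst_pref u c (mapv_pref (swap x u) p) = subst_pref x c p.
Proof. induction p; simpl; intros H1 H2; try discriminate.
  - rewrite subst_swap_name; auto.
  - rewrite !subst_swap_name, IHp; auto.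
Qed.

Lemma subst_swap_pref_some x u c p y : pbv p = Some y -> ~ pvar u p ->
  subst_pref u c (mapv_pref (swap x u) p) = set_pbv (subst_pref x c p) (swap x u y).
Proof. induction p; simpl; intros H1 H2; try discriminate.
  - inversion H1; subst. rewrite subst_swap_name; auto.
  - rewrite !subst_swap_name, IHp; auto.
Qed.

Lemma subst_rename_alpha x u c P : ~ occurs_v u P ->
  alpha (subst P x c) (subst (mapv (swap x u) P) u c).
Proof. induction P; simpl; intros H.
  - apply al_refl.
  - rewrite pbv_mapv. destruct (pbv p) as [y|] eqn:Ep; simpl.
    + rewrite (subst_swap_pref_some x u c p y) by auto.
      destruct (Nat.eq_dec y x).
      * subst. rewrite swap_l, !Nat.eqb_refl. apply alpha_in_swap; auto. rewrite pbv_subst; auto.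
      * assert (y <> u) by (intro; subst; apply H; left; clear -Ep; induction p; simpl in *;
          try discriminate; auto; inversion Ep; auto).
        rewrite swap_o by auto. destruct (Nat.eqb_spec y x); try lia. destruct (Nat.eqb_spec y u); try lia.
        rewrite set_pbv_id by (rewrite pbv_subst; auto). apply al_pre, IHP; auto.
    + rewrite subst_swap_pref_none by auto. apply al_pre, IHP; auto.
  - apply al_par; auto.
  - apply al_res; auto.
  - apply al_rep; auto.
Qed.

Lemma binder_not_free w y u P R : ~ occurs_v u P -> w <> y -> w <> u ->
  alpha (mapv (swap w u) P) (mapv (swap y u) R) -> ~ fv w R.
Proof.
  intros Hu Hwy Hwu Ha Hf. apply (alpha_fv w) in Ha.
  rewrite !fv_swapv, swap_l, (swap_o y u w) in Ha by auto. apply Ha in Hf. apply Hu, fv_occ; auto.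
Qed.

Lemma subst_alpha_n n : forall P P' w c, size P <= n -> alpha P P' -> ~ chan_bound c P -> ~ chan_bound c P' ->
  alpha (subst P w c) (subst P' w c).
Proof. induction n; intros P P' w c Hs Ha H1 H2; [pose proof (size_pos P); lia|].
  destruct P as [|p P|Q1 Q2|k P|P]; simpl in Hs.
  - apply alpha_nil_l in Ha; subst; apply al_refl.
  - apply alpha_pre in Ha. destruct Ha as [p' [R' [-> [[N [-> Ha]]|[y [y' [Sy [-> Ha]]]]]]]].
    + simpl. rewrite N. apply al_pre, IHn; auto; lia.
    + simpl in *. rewrite Sy, (pbv_set p y' y) by auto.
      set (T := if Nat.eqb y w then P else subst P w c).
      set (T' := if Nat.eqb y' w then R' else subst R' w c).
      destruct (fresh_v [P; R'; T; T'] [w; y; y']) as [u [Hu1 Hu2]]. simpl in Hu2.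
      assert (~ occurs_v u P) by (apply Hu1; simpl; auto).
      assert (~ occurs_v u R') by (apply Hu1; simpl; auto).
      assert (~ occurs_v u T) by (apply Hu1; simpl; auto).
      assert (~ occurs_v u T') by (apply Hu1; simpl; auto).
      eapply al_trans. apply (alpha_in_swap _ y u); auto. rewrite pbv_subst; auto.
      eapply al_trans; [|apply al_sym, (alpha_in_swap _ y' u)]; auto.
      2:{ rewrite pbv_subst. apply (pbv_set p y' y); auto. }
      rewrite <- set_pbv_subst, !set_pbv_set. apply al_pre.
      specialize (Ha u H H0).
      subst T T'. destruct (Nat.eqb_spec y w); destruct (Nat.eqb_spec y' w); subst.
      * auto.
      * rewrite subst_notfree; auto. apply (binder_not_free w y' u P R'); auto; intro; subst; tauto.
      * rewrite subst_notfree; auto. apply (binder_not_free w y u R' P); auto; try (intro; subst; tauto).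
        apply al_sym; auto.
      * rewrite !mapv_subst by apply swap_inj. rewrite !(swap_o _ _ w) by auto.
        apply IHn; auto. rewrite size_mapv; lia. rewrite cb_mapv; auto. rewrite cb_mapv; auto.
  - apply alpha_par in Ha. destruct Ha as [Q1' [Q2' [-> [Ha1 Ha2]]]]. simpl in *.
    apply al_par; apply IHn; auto; lia.
  - apply alpha_res in Ha. destruct Ha as [k' [R' [-> Ha]]]. simpl in *.
    assert (k <> c) by tauto. assert (k' <> c) by tauto.
    destruct (fresh_c [P; R'; subst P w c; subst R' w c] [c]) as [z [Hz1 Hz2]]. simpl in Hz2.
    assert (~ occurs_c z P) by (apply Hz1; simpl; auto).
    assert (~ occurs_c z R') by (apply Hz1; simpl; auto).
    assert (~ occurs_c z (subst P w c)) by (apply Hz1; simpl; auto).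
    assert (~ occurs_c z (subst R' w c)) by (apply Hz1; simpl; auto).
    eapply al_trans. apply (alpha_res_swap k z); auto.
    eapply al_trans; [|apply al_sym, (alpha_res_swap k' z)]; auto.
    apply al_res. specialize (Ha z H3 H4).
    rewrite !mapc_subst. rewrite (swap_o k z c), (swap_o k' z c) by auto.
    apply IHn; auto. rewrite size_mapc; lia.
    rewrite cb_swap, swap_o by auto; tauto. rewrite cb_swap, swap_o by auto; tauto.
  - apply alpha_rep in Ha. destruct Ha as [R' [-> Ha]]. simpl in *. apply al_rep, IHn; auto; lia.
Qed.

Lemma subst_alpha P P' w c : alpha P P' -> ~ chan_bound c P -> ~ chan_bound c P' ->
  alpha (subst P w c) (subst P' w c).
Proof. intros; eapply subst_alpha_n; eauto. Qed.

Lemma input_subst_alpha a x P a' x' P' c : alpha (Pre (PIn a x) P) (Pre (PIn a' x') P') ->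
  ~ chan_bound c P -> ~ chan_bound c P' -> alpha (subst P x c) (subst P' x' c).
Proof. intros Ha H1 H2. apply alpha_pre in Ha.
  destruct Ha as [p' [R' [E [[N _]|[y [y' [Sy [Ep Ha]]]]]]]]; [discriminate|].
  simpl in *. inversion Sy; subst y. subst p'. simpl in E. inversion E. subst R' y' a'.
  destruct (fresh_v [P; P'] [x; x']) as [u [Hu1 Hu2]]. simpl in Hu2.
  assert (~ occurs_v u P) by (apply Hu1; simpl; auto).
  assert (~ occurs_v u P') by (apply Hu1; simpl; auto).
  eapply al_trans. apply (subst_rename_alpha x u); auto.
  eapply al_trans; [|apply al_sym, (subst_rename_alpha x' u)]; auto.
  apply subst_alpha; auto; rewrite cb_mapv; auto.
Qed.

Lemma act_names_mapa f a k : inj f -> (act_names (mapa f a) (f k) <-> act_names a k).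
Proof. intros Hf. destruct a; simpl; try tauto;
  split; intros [H|H]; try (apply Hf in H); subst; auto. Qed.

Lemma act_bn_mapa f a c : act_bn (mapa f a) c -> exists d, act_bn a d /\ c = f d.
Proof. destruct a; simpl; try tauto. intros ->; eauto. Qed.

Lemma act_bn_names a c : act_bn a c -> act_names a c.
Proof. destruct a; simpl; intros; try tauto; auto. Qed.

Lemma mapa_id f a : (forall c, act_names a c -> f c = c) -> mapa f a = a.
Proof. destruct a; simpl; intros H; auto; rewrite !H; auto. Qed.

Definition act_chans (a : act) : list chan :=
  match a with AOut k l | AIn k l | ABOut k l => [k; l] | ATau => [] end.

Lemma act_chans_in a c : act_names a c -> In c (act_chans a).
Proof. destruct a; simpl; intuition subst; auto. Qed.

Lemma trans_mapc f P a Q : inj f -> trans P a Q -> trans (mapc f P) (mapa f a) (mapc f Q).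
Proof. intros Hf H. induction H; simpl.
  - apply t_out.
  - rewrite mapc_subst. apply t_in. rewrite cb_mapc; auto.
  - apply t_match. auto.
  - apply t_res; auto. rewrite act_names_mapa; auto.
  - apply t_open; auto; intro E; apply Hf in E; auto.
  - apply t_parl; auto. intros c Hc. apply act_bn_mapa in Hc. destruct Hc as [d [Hd ->]].
    rewrite free_mapc; auto.
  - apply t_parr; auto. intros c Hc. apply act_bn_mapa in Hc. destruct Hc as [d [Hd ->]].
    rewrite free_mapc; auto.
  - eapply t_comml; eauto.
  - eapply t_commr; eauto.
  - eapply t_closel; eauto. rewrite free_mapc; auto.
  - eapply t_closer; eauto. rewrite free_mapc; auto.
  - apply t_rep_act; auto.
  - eapply t_rep_comm; eauto.
  - eapply t_rep_close; eauto. rewrite free_mapc; auto.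
  - eapply t_alpha; [apply alpha_mapc; eauto|]; auto.
Qed.

Lemma trans_swap a b P al Q :
  trans P al Q -> trans (mapc (swap a b) P) (mapa (swap a b) al) (mapc (swap a b) Q).
Proof. apply trans_mapc, swap_inj. Qed.

Ltac fo_cases := repeat match goal with
  | H: _ /\ _ |- _ => destruct H
  | H: _ \/ _ |- _ => destruct H
  | IH: forall c, fo c ?Q -> _, H: fo ?c ?Q |- _ => apply IH in H
  end; simpl in *; try tauto; try (left; split; [congruence|tauto]).

Lemma trans_fo P a P' : trans P a P' -> forall c, fo c P' -> fo c P \/ act_bn a c.
Proof. intros H; induction H; intros c0 Hc; simpl in *.
  - auto.
  - rewrite fo_subst in Hc; auto.
  - apply IHtrans in Hc. simpl in Hc. tauto.
  - destruct Hc as [H1 H2]. apply IHtrans in H2. destruct H2; auto.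
  - apply IHtrans in Hc. simpl in Hc. destruct (Nat.eq_dec c0 l); auto.
      left; split; [intro; subst; auto|tauto].
  - fo_cases.
  - fo_cases.
  - fo_cases.
  - fo_cases.
  - fo_cases; congruence.
  - fo_cases; congruence.
  - fo_cases.
  - fo_cases.
  - fo_cases; congruence.
  - apply IHtrans in Hc. rewrite (alpha_fo _ _ _ H); auto.
Qed.

Lemma trans_out_fo P a P' : trans P a P' -> forall k c, a = AOut k c -> fo c P.
Proof. intros H; induction H; intros k0 c0 E; try discriminate; simpl in *.
  - inversion E; subst; auto.
  - apply IHtrans in E; simpl in E; tauto.
  - subst. split; [intro; subst; simpl in H0; tauto|]. eauto.
  - left; eauto.
  - right; eauto.
  - eauto.
  - apply (alpha_fo _ _ _ H); eauto.
Qed.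

Lemma pre_no_bout X a X' : trans X a X' -> forall p P, alpha X (Pre p P) -> forall k d, a <> ABOut k d.
Proof. intros H; induction H; intros p0 P0 Ha k0 d0; try discriminate;
  try (apply alpha_pre_r in Ha; destruct Ha as [? [? Ha]]; discriminate).
  - eapply IHtrans. apply al_refl.
  - eapply IHtrans. eapply al_trans; [apply al_sym|]; eauto.
Qed.

Lemma trans_bout_fresh P a P' : trans P a P' -> forall k d, a = ABOut k d -> k <> d /\ ~ free_chan d P.
Proof. intros H; induction H; intros k0 d0 E; try discriminate; simpl in *.
  - exfalso. eapply pre_no_bout; eauto. apply al_refl.
  - subst. destruct (IHtrans _ _ eq_refl) as [A B]. split; auto. intros [C D]; auto.
  - inversion E; subst. split; auto. tauto.
  - subst. destruct (IHtrans _ _ eq_refl) as [A B]. split; auto. specialize (H0 d0). simpl in H0. tauto.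
  - subst. destruct (IHtrans _ _ eq_refl) as [A B]. split; auto. specialize (H0 d0). simpl in H0. tauto.
  - subst. destruct (IHtrans _ _ eq_refl) as [A B]. split; auto.
  - subst. destruct (IHtrans _ _ eq_refl) as [A B]. split; auto. rewrite (alpha_free _ _ _ H); auto.
Qed.

Lemma out_inv X a X' : trans X a X' -> forall k c W, alpha X (Pre (POut (NC k) c) W) ->
  a = AOut k c /\ alpha X' W.
Proof. intros H; induction H; intros k0 c0 W Ha;
  try (apply al_sym, alpha_pre in Ha; destruct Ha as [? [? [Ha _]]]; discriminate).
  - apply alpha_pre in Ha. destruct Ha as [p' [P' [E [[_ [-> Ha]]|[y1 [y2 [Hbv _]]]]]]]; [|discriminate].
    inversion E; subst; auto.
  - apply alpha_pre in Ha. destruct Ha as [p' [P' [E [[N _]|[y1 [y2 [Hbv [-> _]]]]]]]]; [discriminate|].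
    simpl in E; discriminate.
  - apply alpha_peel in Ha. destruct Ha as [? [? [E _]]]; discriminate.
  - eapply IHtrans. eapply al_trans; [apply al_sym|]; eauto.
Qed.

Lemma inp_inv X a X' : trans X a X' -> forall k x W, alpha X (Pre (PIn (NC k) x) W) ->
  exists c, a = AIn k c.
Proof. intros H; induction H; intros k0 x0 W Ha;
  try (apply al_sym, alpha_pre in Ha; destruct Ha as [? [? [Ha _]]]; discriminate).
  - apply alpha_pre in Ha. destruct Ha as [p' [P' [E [[N [Ep _]]|[y1 [y2 [Hbv _]]]]]]]; subst; discriminate.
  - apply alpha_pre in Ha. destruct Ha as [p' [P' [E [[N _]|[y1 [y2 [Hbv [-> _]]]]]]]]; [discriminate|].
    simpl in E; inversion E; subst; eauto.
  - apply alpha_peel in Ha. destruct Ha as [? [? [E _]]]; discriminate.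
  - eapply IHtrans. eapply al_trans; [apply al_sym|]; eauto.
Qed.

(* A channel restricted by (nu l) cannot be used as the subject of an output under
   that restriction: (nu l) l<l>.W has no transition at all. *)
Lemma res_out_form k P l W : alpha (Res k P) (Res l (Pre (POut (NC l) l) W)) ->
  exists W', alpha P (Pre (POut (NC k) k) W').
Proof. intros Ha. apply alpha_res in Ha. destruct Ha as [k' [P' [E Ha]]]. inversion E; subst.
  destruct (fresh_c [P; Pre (POut (NC k') k') W] []) as [z [Hz _]].
  specialize (Ha z (Hz _ (or_introl eq_refl)) (Hz _ (or_intror (or_introl eq_refl)))).
  simpl in Ha. rewrite swap_l in Ha. apply (alpha_swap k z) in Ha. rewrite swap_mapc_inv in Ha.
  simpl in Ha. rewrite swap_r in Ha. eauto.
Qed.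

Lemma self_output_stuck X a X' : trans X a X' -> forall l W, alpha X (Res l (Pre (POut (NC l) l) W)) -> False.
Proof. intros H; induction H; intros l0 W Ha;
  try (apply al_sym, alpha_res in Ha; destruct Ha as [? [? [Ha _]]]; discriminate).
  - apply res_out_form in Ha. destruct Ha as [W' Ha].
    destruct (out_inv _ _ _ H _ _ _ Ha) as [-> _]. simpl in H0; tauto.
  - apply res_out_form in Ha. destruct Ha as [W' Ha].
    destruct (out_inv _ _ _ H _ _ _ Ha) as [E _]. inversion E; subst; tauto.
  - eapply IHtrans. eapply al_trans; [apply al_sym|]; eauto.
Qed.

Lemma res_out_trans_inv X a X' : trans X a X' -> forall l k Z,
    alpha X (Res l (Pre (POut (NC k) l) Z)) -> k <> l ->
  exists d z, a = ABOut k d /\ k <> d /\ ~ occurs_c z Z /\ z <> l /\ z <> d /\ z <> k /\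
    (forall c, free_chan c (Res l (Pre (POut (NC k) l) Z)) -> c <> d) /\
    alpha X' (mapc (swap d z) (mapc (swap l z) Z)).
Proof. intros H; induction H; intros l0 k0 Z Ha Hk;
  try (apply al_sym, alpha_res in Ha; destruct Ha as [? [? [Ha _]]]; discriminate).
  -
    apply alpha_res in Ha. destruct Ha as [k9 [P9 [E Ha]]]. injection E as E1 E2. subst k9 P9.
    destruct (fresh_c [P; Pre (POut (NC k0) l0) Z] [k; k0; l0]) as [z [Hz Hz']]. simpl in Hz'.
    specialize (Ha z (Hz _ (or_introl eq_refl)) (Hz _ (or_intror (or_introl eq_refl)))).
    simpl in Ha. rewrite swap_l, (swap_o l0 z k0) in Ha by (auto; intuition).
    apply (alpha_swap k z) in Ha. rewrite swap_mapc_inv in Ha. simpl in Ha. rewrite swap_r in Ha.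
    destruct (out_inv _ _ _ H _ _ _ Ha) as [-> _]. simpl in H0; tauto.
  -
    assert (Hf: free_chan k0 (Res l0 (Pre (POut (NC k0) l0) Z))) by (simpl; auto).
    rewrite <- (alpha_free _ _ _ Ha) in Hf. simpl in Hf. destruct Hf as [Hkl _].
    pose proof Ha as Ha0.
    apply alpha_res in Ha. destruct Ha as [k9 [P9 [E Ha]]]. injection E as E1 E2. subst k9 P9.
    destruct (fresh_c [P; Pre (POut (NC k0) l0) Z] [l; k0; l0]) as [z [Hz Hz']]. simpl in Hz'.
    assert (Hz1: ~ occurs_c z Z) by (intro; apply (Hz _ (or_intror (or_introl eq_refl))); simpl; auto).
    specialize (Ha z (Hz _ (or_introl eq_refl)) (Hz _ (or_intror (or_introl eq_refl)))).
    simpl in Ha. rewrite swap_l, (swap_o l0 z k0) in Ha by (auto; intuition).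
    apply (alpha_swap l z) in Ha. rewrite swap_mapc_inv in Ha. simpl in Ha. rewrite swap_r in Ha.
    rewrite (swap_o l z k0) in Ha by (auto; intuition).
    destruct (out_inv _ _ _ H _ _ _ Ha) as [E Ha2]. inversion E; subst.
    exists l, z; repeat split; auto; try (intro; subst; tauto).
    intros c Hc Hc'. subst c. rewrite <- (alpha_free _ _ _ Ha0) in Hc. simpl in Hc; tauto.
  - eapply IHtrans; eauto. eapply al_trans; [apply al_sym|]; eauto.
Qed.

(* The processes of the theorem.  [recv_match l m y q] is m(y).[y=l]q.0 and
   [recv_nil m y] is m(y).0.  [sender l kk mm y q] is (nu l) k<l>.m(y).[y=l]q.0, where
   the option arguments encode k and m relatively to the binder l (None meaning "the
   bound channel l itself"), so that renaming l keeps them consistent. *)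
Definition odflt (l : chan) (o : option chan) : chan := match o with Some c => c | None => l end.

Definition recv_match (l m : chan) (y : var) (q : prefix) : proc :=
  Pre (PIn (NC m) y) (Pre (PMatch (NV y) (NC l) q) Nil).

Definition recv_nil (m : chan) (y : var) : proc := Pre (PIn (NC m) y) Nil.

Definition sender (l : chan) (kk mm : option chan) (y : var) (q : prefix) : proc :=
  Res l (Pre (POut (NC (odflt l kk)) l) (recv_match l (odflt l mm) y q)).

Definition sender_nil (l : chan) (kk mm : option chan) (y : var) : proc :=
  Res l (Pre (POut (NC (odflt l kk)) l) (recv_nil (odflt l mm) y)).

Lemma odflt_map f l o : f (odflt l o) = odflt (f l) (option_map f o).
Proof. destruct o; auto. Qed.

Lemma mapc_recv_match f l m y q : mapc f (recv_match l m y q) = recv_match (f l) (f m) y (mapc_pref f q).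
Proof. reflexivity. Qed.

Lemma mapc_recv_nil f m y : mapc f (recv_nil m y) = recv_nil (f m) y.
Proof. reflexivity. Qed.

Lemma mapc_sender f l kk mm y q :
  mapc f (sender l kk mm y q) = sender (f l) (option_map f kk) (option_map f mm) y (mapc_pref f q).
Proof. unfold sender. simpl. rewrite !odflt_map. reflexivity. Qed.

Lemma mapc_sender_nil f l kk mm y :
  mapc f (sender_nil l kk mm y) = sender_nil (f l) (option_map f kk) (option_map f mm) y.
Proof. unfold sender_nil. simpl. rewrite !odflt_map. reflexivity. Qed.

Lemma subst_recv_match l m y q x c :
  subst (recv_match l m y q) x c = recv_match l m y (if Nat.eqb y x then q else subst_pref x c q).
Proof.
  unfold recv_match. simpl. destruct (Nat.eqb_spec y x); auto. simpl.
  destruct (Nat.eqb_spec y x); try lia. f_equal. f_equal.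
  destruct (pbv q); [destruct (Nat.eqb _ _)|]; auto.
Qed.

Lemma subst_recv_nil m y x c : subst (recv_nil m y) x c = recv_nil m y.
Proof. unfold recv_nil. simpl. destruct (Nat.eqb y x); auto. Qed.

Lemma subst_sender l kk mm y q x c : exists q', subst (sender l kk mm y q) x c = sender l kk mm y q'.
Proof. unfold sender. cbn [subst subst_pref subst_name pbv]. rewrite subst_recv_match. eauto. Qed.

Lemma subst_sender_nil l kk mm y x c : subst (sender_nil l kk mm y) x c = sender_nil l kk mm y.
Proof. unfold sender_nil. cbn [subst subst_pref subst_name pbv]. rewrite subst_recv_nil. auto. Qed.

Lemma cb_sender c l kk mm y q : chan_bound c (sender l kk mm y q) <-> l = c.
Proof. unfold sender, recv_match; simpl; tauto. Qed.

Lemma cb_sender_nil c l kk mm y : chan_bound c (sender_nil l kk mm y) <-> l = c.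
Proof. unfold sender_nil, recv_nil; simpl; tauto. Qed.

Lemma occ_sender_nil_body c l kk mm y :
  occurs_c c (Pre (POut (NC (odflt l kk)) l) (recv_nil (odflt l mm) y)) ->
  c = odflt l kk \/ c = l \/ c = odflt l mm.
Proof. unfold recv_nil; simpl. intuition congruence. Qed.

Lemma sender_trans_inv X a X' : trans X a X' -> forall l k mm y q,
    alpha X (sender l (Some k) mm y q) -> k <> l -> mm <> Some l ->
  exists d, a = ABOut k d /\ k <> d /\ mm <> Some d /\ exists q', alpha X' (recv_match d (odflt d mm) y q').
Proof. intros H l k mm y q Ha Hk Hm. unfold sender in Ha. simpl in Ha.
  destruct (res_out_trans_inv _ _ _ H _ _ _ Ha Hk) as [d [z [E [Hkd [Hz [Hzl [Hzd [Hzk [Hfr Ha']]]]]]]]].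
  exists d. rewrite !mapc_recv_match in Ha'. rewrite swap_l, swap_r in Ha'.
  destruct mm as [m|]; simpl in *.
  - assert (m <> l) by congruence.
    assert (m <> z) by (intro; subst; apply Hz; simpl; auto).
    assert (m <> d) by (apply Hfr; simpl; split; auto).
    rewrite (swap_o l z m), (swap_o d z m) in Ha' by auto.
    repeat split; auto. congruence. eauto.
  - rewrite swap_l, swap_r in Ha'. repeat split; auto. discriminate. eauto.
Qed.

Lemma sender_nil_trans_inv X a X' : trans X a X' -> forall l k mm y,
    alpha X (sender_nil l (Some k) mm y) -> k <> l -> mm <> Some l ->
  exists d, a = ABOut k d /\ k <> d /\ mm <> Some d /\ alpha X' (recv_nil (odflt d mm) y).
Proof. intros H l k mm y Ha Hk Hm. unfold sender_nil in Ha. simpl in Ha.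
  destruct (res_out_trans_inv _ _ _ H _ _ _ Ha Hk) as [d [z [E [Hkd [Hz [Hzl [Hzd [Hzk [Hfr Ha']]]]]]]]].
  exists d. rewrite !mapc_recv_nil in Ha'.
  destruct mm as [m|]; simpl in *.
  - assert (m <> l) by congruence.
    assert (m <> z) by (intro; subst; apply Hz; simpl; auto).
    assert (m <> d) by (apply Hfr; simpl; split; auto).
    rewrite (swap_o l z m), (swap_o d z m) in Ha' by auto.
    repeat split; auto. congruence.
  - rewrite swap_l, swap_r in Ha'. repeat split; auto. discriminate.
Qed.

Lemma swap_odflt l z o : o <> Some l -> o <> Some z -> swap l z (odflt l o) = odflt z o.
Proof. destruct o as [c|]; intros A B; simpl; [apply swap_o; congruence|apply swap_l]. Qed.

Lemma sender_rename l kk mm y q z : kk <> Some l -> mm <> Some l -> kk <> Some z -> mm <> Some z ->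
  ~ occurs_c z (Pre (POut (NC (odflt l kk)) l) (recv_match l (odflt l mm) y q)) ->
  alpha (sender l kk mm y q) (sender z kk mm y (mapc_pref (swap l z) q)).
Proof.
  intros H1 H2 H3 H4 H5. unfold sender. eapply al_trans; [apply alpha_res_swap; eauto|].
  simpl. rewrite swap_l, !swap_odflt by auto. apply al_refl.
Qed.

Lemma sender_nil_rename l kk mm y z : kk <> Some l -> mm <> Some l -> kk <> Some z -> mm <> Some z ->
  ~ occurs_c z (Pre (POut (NC (odflt l kk)) l) (recv_nil (odflt l mm) y)) ->
  alpha (sender_nil l kk mm y) (sender_nil z kk mm y).
Proof.
  intros H1 H2 H3 H4 H5. unfold sender_nil. eapply al_trans; [apply alpha_res_swap; eauto|].
  simpl. rewrite swap_l, !swap_odflt by auto. apply al_refl.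
Qed.

Lemma sender_open l k mm y q :
  k <> l -> trans (sender l (Some k) mm y q) (ABOut k l) (recv_match l (odflt l mm) y q).
Proof. intros. unfold sender. apply t_open; auto. simpl. apply t_out. Qed.

Lemma sender_nil_open l k mm y :
  k <> l -> trans (sender_nil l (Some k) mm y) (ABOut k l) (recv_nil (odflt l mm) y).
Proof. intros. unfold sender_nil. apply t_open; auto. simpl. apply t_out. Qed.

Lemma trans_recv_nil m y l : trans (recv_nil m y) (AIn m l) Nil.
Proof. change Nil with (subst Nil y l). unfold recv_nil. apply t_in. simpl; auto. Qed.

Lemma subst_match_nil y l0 q l : exists q',
    subst (Pre (PMatch (NV y) (NC l0) q) Nil) y l = Pre (PMatch (NC l) (NC l0) q') Nil.
Proof. simpl. rewrite Nat.eqb_refl. eexists. f_equal. destruct (pbv q); [destruct (Nat.eqb _ _)|]; auto. Qed.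

Lemma trans_recv_match l0 m y q l : exists q',
    trans (recv_match l0 m y q) (AIn m l) (Pre (PMatch (NC l) (NC l0) q') Nil).
Proof. destruct (subst_match_nil y l0 q l) as [q' E']. exists q'. rewrite <- E'. apply t_in. simpl; auto. Qed.

(* The correspondence.  [Corr L pk A B]: A and B are identical except that
   - a receiver m(y).[y=l]q.0 in A may stand for m(y').0 in B when l is in the list L
     of protected channels (corr_recv), and a failed match [c=d]q.0 for 0;
   - a restricted channel k that is not an output object of B may be protected
     (corr_prot), while an unprotected restriction removes k from L (corr_res);
   - pk = Some k describes, under (nu k), the configuration of the theorem before the
     sender has fired (corr_sender_par), and the sender on its own bound name, which can
     never fire, is related to its match-free version (corr_dead_sender). *)
Definition rem (k : chan) (L : list chan) : list chan := remove Nat.eq_dec k L.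

Lemma in_rem c k L : In c (rem k L) <-> In c L /\ c <> k.
Proof. unfold rem. split; intro H. apply in_remove in H; auto. apply in_in_remove; tauto. Qed.

Definition input_form (k : chan) (A : proc) := exists x P, A = Pre (PIn (NC k) x) P.

Inductive Corr : list chan -> option chan -> proc -> proc -> Prop :=
| corr_nil L : Corr L None Nil Nil
| corr_pre L p A B : Corr L None A B -> Corr L None (Pre p A) (Pre p B)
| corr_par L A1 A2 B1 B2 : Corr L None A1 B1 -> Corr L None A2 B2 -> Corr L None (Par A1 A2) (Par B1 B2)
| corr_rep L A B : Corr L None A B -> Corr L None (Rep A) (Rep B)
| corr_res L k A B : Corr (rem k L) None A B -> Corr L None (Res k A) (Res k B)
| corr_prot L k A B : Corr (k :: rem k L) None A B -> ~ fo k B -> Corr L None (Res k A) (Res k B)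
| corr_failed_match L c d q : c <> d -> Corr L None (Pre (PMatch (NC c) (NC d) q) Nil) Nil
| corr_recv L m y l q y2 : In l L -> Corr L None (recv_match l m y q) (recv_nil m y2)
| corr_dead_sender L l mm y q : mm <> Some l -> Corr L None (sender l None mm y q) (sender_nil l None mm y)
| corr_sender_res L k A B : Corr [] (Some k) A B -> Corr L None (Res k A) (Res k B)
| corr_sender_par k l mm y q A2 B2 : mm <> Some l -> k <> l -> Corr [] None A2 B2 -> input_form k A2 ->
    Corr [] (Some k) (Par (sender l (Some k) mm y q) A2) (Par (sender_nil l (Some k) mm y) B2).

Lemma corr_free L pk A B c : Corr L pk A B -> free_chan c B -> free_chan c A.
Proof. intros H; induction H; unfold sender, sender_nil, recv_match, recv_nil in *; simpl in *;
    intros Hc; tauto. Qed.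

Lemma corr_protected_gen L pk A B : Corr L pk A B -> pk = None -> forall L', (forall c,
    In c L -> free_chan c A -> In c L') ->
  Corr L' None A B.
Proof. intros H; induction H; intros Hpk L' HL; try discriminate.
  - constructor.
  - constructor; apply IHCorr; auto. intros c H1 H2; apply HL; simpl; auto.
  - constructor; [apply IHCorr1|apply IHCorr2]; auto; intros c H1 H2; apply HL; simpl; auto.
  - constructor; apply IHCorr; auto.
  - constructor; apply IHCorr; auto. intros c H1 H2. rewrite in_rem in *. destruct H1 as [H1 H3].
    split; auto; apply HL; simpl; auto.
  - apply corr_prot; auto. apply IHCorr; auto. intros c H1 H2. simpl in *.
      destruct H1 as [H1|H1]; [left; auto|].
    right. rewrite in_rem in *. destruct H1 as [H1 H3]. split; auto; apply HL; simpl; auto.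
  - apply corr_failed_match; auto.
  - apply corr_recv. apply HL; auto. unfold recv_match; simpl; auto.
  - apply corr_dead_sender; auto.
  - apply corr_sender_res; auto.
Qed.

Lemma corr_protected L A B L' : Corr L None A B -> (forall c,
    In c L -> free_chan c A -> In c L') -> Corr L' None A B.
Proof. intros; eapply corr_protected_gen; eauto. Qed.

Lemma corr_rem_fresh L A B z : ~ In z L -> Corr L None A B -> Corr (rem z L) None A B.
Proof.
  intros Hz HE. eapply corr_protected; eauto.
  intros c Hc _. rewrite in_rem. split; auto. intro; subst; tauto.
Qed.

Lemma corr_unprotect L A B l : Corr L None A B -> ~ free_chan l A -> Corr (rem l L) None A B.
Proof.
  intros HE Hl. eapply corr_protected; eauto.
  intros c Hc Hf. rewrite in_rem. split; auto. intro; subst; auto.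
Qed.

Lemma option_map_neq f o l : inj f -> o <> Some l -> option_map f o <> Some (f l).
Proof. intros Hf H. destruct o; simpl; try discriminate. intro Heq. inversion Heq. apply Hf in H1.
    subst; auto. Qed.

Lemma corr_mapc f L pk A B : inj f -> Corr L pk A B -> Corr (map f L) (option_map f pk) (mapc f A) (mapc f B).
Proof. intros Hf H; induction H.
  - simpl; constructor.
  - simpl; constructor; auto.
  - simpl; constructor; auto.
  - simpl; constructor; auto.
  - simpl; constructor. eapply corr_protected; eauto. intros c H1 _. apply in_map_iff in H1.
    destruct H1 as [c0 [<- H1]]. rewrite in_rem in *. destruct H1. split. apply in_map; auto.
    intro E'; apply Hf in E'; auto.
  - simpl; apply corr_prot. eapply corr_protected; eauto. intros c H1 _. simpl in H1.
      destruct H1 as [H1|H1]; [left; auto|].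
    apply in_map_iff in H1. destruct H1 as [c0 [<- H1]]. rewrite in_rem in *. destruct H1. right.
    rewrite in_rem. split. apply in_map; auto. intro E'; apply Hf in E'; auto.
    rewrite fo_mapc; auto.
  - simpl; apply corr_failed_match. intro E'; apply Hf in E'; auto.
  - rewrite mapc_recv_match, mapc_recv_nil. apply corr_recv. apply in_map; auto.
  - rewrite mapc_sender, mapc_sender_nil. apply corr_dead_sender. apply option_map_neq; auto.
  - simpl; apply corr_sender_res. auto.
  - cbn [mapc]. rewrite mapc_sender, mapc_sender_nil. simpl. apply corr_sender_par; auto;
    try (apply option_map_neq; auto); try (intro E'; apply Hf in E'; auto);
    try (destruct H2 as [x [P ->]]; simpl; exists x, (mapc f P); auto).
Qed.

Lemma corr_res_rename L k A B z : Corr (rem k L) None A B -> ~ In z L ->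
  Corr (rem z L) None (mapc (swap k z) A) (mapc (swap k z) B).
Proof. intros H Hz. apply (corr_mapc (swap k z)) in H; [|apply swap_inj]. simpl in H.
  eapply corr_protected; eauto. intros c H1 _. apply in_map_iff in H1. destruct H1 as [c0 [<- H1]].
  rewrite in_rem in *. destruct H1. assert (c0 <> z) by (intro; subst; auto).
  rewrite swap_o by auto. auto. Qed.

Lemma corr_prot_rename L k A B z : Corr (k :: rem k L) None A B -> ~ In z L ->
  Corr (z :: rem z L) None (mapc (swap k z) A) (mapc (swap k z) B).
Proof. intros H Hz. apply (corr_mapc (swap k z)) in H; [|apply swap_inj]. simpl in H. rewrite swap_l in H.
  eapply corr_protected; eauto. intros c H1 _. simpl in H1. destruct H1 as [H1|H1]; [left; auto|right].
  apply in_map_iff in H1. destruct H1 as [c0 [<- H1]].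
  rewrite in_rem in *. destruct H1. assert (c0 <> z) by (intro; subst; auto).
  rewrite swap_o by auto. auto. Qed.

Lemma corr_refl L P : Corr L None P P.
Proof. revert L; induction P; intros L; constructor; auto. Qed.

Lemma corr_subst L pk A B x c : Corr L pk A B -> ~ In c L -> ~ chan_bound c A -> Corr L pk (subst A
    x c) (subst B x c).
Proof. intros H; induction H; intros HL Hcb.
  - simpl; constructor.
  - simpl in *; constructor. destruct (pbv p) as [v|]; [destruct (Nat.eqb v x)|]; auto.
  - simpl in *; constructor; auto.
  - simpl in *; constructor; auto.
  - simpl in *; constructor. apply IHCorr; auto. rewrite in_rem; tauto.
  - simpl in *; apply corr_prot. apply IHCorr; auto. simpl; rewrite in_rem; intuition.
    rewrite fo_subst; auto.
  - simpl in *.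
    replace (match pbv q with Some y => if Nat.eqb y x then Nil else Nil | None => Nil end) with Nil
      by (destruct (pbv q); [destruct (Nat.eqb _ _)|]; auto).
    apply corr_failed_match; auto.
  - rewrite subst_recv_match, subst_recv_nil. apply corr_recv; auto.
  - destruct (subst_sender l None mm y q x c) as [q' ->]. rewrite subst_sender_nil.
      apply corr_dead_sender; auto.
  - simpl in *. apply corr_sender_res. apply IHCorr; auto.
  - cbn [subst]. destruct (subst_sender l (Some k) mm y q x c) as [q' ->].
      rewrite subst_sender_nil. apply corr_sender_par; auto.
    + apply IHCorr; auto. simpl in Hcb; tauto.
    + destruct H2 as [x0 [P ->]]. simpl. eexists; eexists; eauto.
Qed.

Lemma corr_input_form L A B k : Corr L None A B -> input_form k A -> input_form k B.
Proof. intros H [x [P ->]]. inversion H; subst.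
  - exists x, B0; auto.
  - unfold recv_nil. exists y2, Nil; auto.
Qed.

Lemma input_form_alpha k A A' : input_form k A -> alpha A A' -> input_form k A'.
Proof. intros [x [P ->]] Ha. apply alpha_pre in Ha.
  destruct Ha as [p' [P' [-> [[N _]|[y [y' [Hbv [-> _]]]]]]]]; [discriminate|]. simpl.
      exists y', P'; auto. Qed.

Lemma res_rename_away c P z : ~ occurs_c z P -> z <> c ->
  alpha (Res c P) (Res z (mapc (swap c z) P)) /\ ~ chan_bound c (Res z (mapc (swap c z) P)).
Proof.
  intros Hz Hzc. split; [apply alpha_res_swap; auto|].
  simpl. rewrite cb_swap, swap_l. intros [Hq|Hq]; [auto|apply cb_occ in Hq; auto].
Qed.

Lemma sender_avoid l kk mm y q c : kk <> Some l -> mm <> Some l ->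
  exists z q', alpha (sender l kk mm y q) (sender z kk mm y q') /\
    alpha (sender_nil l kk mm y) (sender_nil z kk mm y) /\ kk <> Some z /\ mm <> Some z /\ z <> c.
Proof.
  intros Hk Hm. destruct (Nat.eq_dec l c) as [<-|Hlc]; [|exists l, q; repeat split; auto using al_refl].
  destruct (fresh_c [Pre (POut (NC (odflt l kk)) l) (recv_match l (odflt l mm) y q);
                     Pre (POut (NC (odflt l kk)) l) (recv_nil (odflt l mm) y)]
                    [l; odflt l kk; odflt l mm]) as [z [Hz1 Hz2]].
  assert (Hk' : kk <> Some z) by (intro; subst; simpl in Hz2; tauto).
  assert (Hm' : mm <> Some z) by (intro; subst; simpl in Hz2; tauto).
  exists z, (mapc_pref (swap l z) q); repeat split; auto.
  - apply sender_rename; auto. apply Hz1; simpl; auto.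
  - apply sender_nil_rename; auto. apply Hz1; simpl; auto.
  - intro; subst; simpl in Hz2; tauto.
Qed.

Lemma corr_avoid_bound L pk A B c : Corr L pk A B -> exists A2 B2, alpha A A2 /\ alpha B B2 /\
  Corr L pk A2 B2 /\ ~ chan_bound c A2 /\ ~ chan_bound c B2.
Proof.
  intros H; induction H;
    try destruct IHCorr as [A3 [B3 [HA [HB [HC [HcA HcB]]]]]];
    try destruct IHCorr1 as [C1 [D1 [H1 [H2 [H3 [H4 H5]]]]]];
    try destruct IHCorr2 as [C2 [D2 [H6 [H7 [H8 [H9 H10]]]]]].
  - exists Nil, Nil; repeat split; try apply al_refl; try apply corr_nil; simpl; auto.
  - exists (Pre p A3), (Pre p B3); repeat split; try apply al_pre; try apply corr_pre; simpl; auto.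
  - exists (Par C1 C2), (Par D1 D2); repeat split; try apply al_par; try apply corr_par; simpl; auto; tauto.
  - exists (Rep A3), (Rep B3); repeat split; try apply al_rep; try apply corr_rep; simpl; auto.
  -
    destruct (Nat.eq_dec k c) as [<-|Hkc];
      [|exists (Res k A3), (Res k B3); repeat split; try apply al_res; try apply corr_res; simpl;
          auto; tauto].
    destruct (fresh_c [A3; B3] (k :: L)) as [z [Hz1 Hz2]]. simpl in Hz2.
    destruct (res_rename_away k A3 z) as [HzA HzcA]; [apply Hz1; simpl; auto|intro; subst; tauto|].
    destruct (res_rename_away k B3 z) as [HzB HzcB]; [apply Hz1; simpl; auto|intro; subst; tauto|].
    exists (Res z (mapc (swap k z) A3)), (Res z (mapc (swap k z) B3)); repeat split; auto;
      try (eapply al_trans; [apply al_res; eauto|auto]).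
    apply corr_res, corr_res_rename; auto.
  -
    assert (Hfo : ~ fo k B3) by (rewrite <- (alpha_fo _ _ _ HB); auto).
    destruct (Nat.eq_dec k c) as [<-|Hkc];
      [|exists (Res k A3), (Res k B3); repeat split; try apply al_res; try apply corr_prot; simpl;
          auto; tauto].
    destruct (fresh_c [A3; B3] (k :: L)) as [z [Hz1 Hz2]]. simpl in Hz2.
    destruct (res_rename_away k A3 z) as [HzA HzcA]; [apply Hz1; simpl; auto|intro; subst; tauto|].
    destruct (res_rename_away k B3 z) as [HzB HzcB]; [apply Hz1; simpl; auto|intro; subst; tauto|].
    exists (Res z (mapc (swap k z) A3)), (Res z (mapc (swap k z) B3)); repeat split; auto;
      try (eapply al_trans; [apply al_res; eauto|auto]).
    apply corr_prot; [apply corr_prot_rename; auto|]. rewrite fo_swap, swap_r. auto.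
  - exists (Pre (PMatch (NC c0) (NC d) q) Nil), Nil; repeat split; try apply al_refl;
      try apply corr_failed_match; simpl; auto.
  - exists (recv_match l m y q), (recv_nil m y2); repeat split; try apply al_refl; try apply corr_recv;
      unfold recv_match, recv_nil; simpl; auto.
  - destruct (sender_avoid l None mm y q c) as [z [q' [HsA [HsB [_ [Hm Hzc]]]]]]; try discriminate; auto.
    exists (sender z None mm y q'), (sender_nil z None mm y); repeat split; auto using corr_dead_sender;
      rewrite ?cb_sender, ?cb_sender_nil; auto.
  -
    destruct (Nat.eq_dec k c) as [<-|Hkc];
      [|exists (Res k A3), (Res k B3); repeat split; try apply al_res; try apply corr_sender_res;
          simpl; auto; tauto].
    destruct (fresh_c [A3; B3] (k :: L)) as [z [Hz1 Hz2]]. simpl in Hz2.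
    destruct (res_rename_away k A3 z) as [HzA HzcA]; [apply Hz1; simpl; auto|intro; subst; tauto|].
    destruct (res_rename_away k B3 z) as [HzB HzcB]; [apply Hz1; simpl; auto|intro; subst; tauto|].
    exists (Res z (mapc (swap k z) A3)), (Res z (mapc (swap k z) B3)); repeat split; auto;
      try (eapply al_trans; [apply al_res; eauto|auto]).
    apply corr_sender_res. apply (corr_mapc (swap k z)) in HC; [|apply swap_inj]. simpl in HC.
    rewrite swap_l in HC. auto.
  - assert (HI : input_form k A3) by (eapply input_form_alpha; eauto).
    destruct (sender_avoid l (Some k) mm y q c) as [z [q' [HsA [HsB [Hk [Hm Hzc]]]]]]; try congruence.
    exists (Par (sender z (Some k) mm y q') A3), (Par (sender_nil z (Some k) mm y) B3);
      repeat split; try (apply al_par; auto).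
    apply corr_sender_par; auto.
    all: cbn [chan_bound]; rewrite ?cb_sender, ?cb_sender_nil; intros [Hq|Hq]; [subst|]; tauto.
Qed.

Lemma corr_inv_par L pk A1 A2 B : Corr L pk (Par A1 A2) B ->
  (pk = None /\ exists B1 B2, B = Par B1 B2 /\ Corr L None A1 B1 /\ Corr L None A2 B2) \/
  (exists k l mm y q B2, pk = Some k /\ L = [] /\ A1 = sender l (Some k) mm y q /\
     B = Par (sender_nil l (Some k) mm y) B2 /\ mm <> Some l /\ k <> l /\ Corr [] None A2 B2 /\
         input_form k A2).
Proof. intros H; inversion H; subst.
  - left; split; auto; eauto.
  - right; do 6 eexists; repeat split; eauto.
Qed.

Lemma corr_inv_res L pk k A B : Corr L pk (Res k A) B -> pk = None /\
  ((exists B', B = Res k B' /\ Corr (rem k L) None A B') \/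
   (exists B', B = Res k B' /\ Corr (k :: rem k L) None A B' /\ ~ fo k B') \/
   (exists B', B = Res k B' /\ Corr [] (Some k) A B') \/
   (exists W, A = Pre (POut (NC k) k) W)).
Proof. intros H; inversion H; subst; split; auto.
  - left; eauto.
  - right; left; eauto.
  - right; right; right. eauto.
  - right; right; left; eauto.
Qed.

Lemma corr_inv_pre L pk p A B : Corr L pk (Pre p A) B -> pk = None /\
  ((exists B', B = Pre p B' /\ Corr L None A B') \/
   (exists c d q, p = PMatch (NC c) (NC d) q /\ A = Nil /\ B = Nil /\ c <> d) \/
   (exists m y l q y2, p = PIn (NC m) y /\ A = Pre (PMatch (NV y) (NC l) q) Nil /\
      B = recv_nil m y2 /\ In l L)).
Proof. intros H; inversion H; subst; split; auto.
  - left; eauto.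
  - right; left; eauto 8.
  - right; right. do 5 eexists; repeat split; eauto.
Qed.

Lemma corr_inv_rep L pk A B : Corr L pk (Rep A) B -> pk = None /\ exists B', B = Rep B' /\ Corr L None A B'.
Proof. intros H; inversion H; subst; split; eauto. Qed.

Definition fw_side (L : list chan) (a : act) (B : proc) :=
  (forall l, In l L -> ~ fo l B) /\ (forall k c, a = AIn k c -> ~ In c L).

Definition fw_result (pk : option chan) (L : list chan) (a : act) (A' B : proc) :=
  match pk with
  | None => exists A0 B' B0, trans B a B' /\ alpha A' A0 /\ alpha B0 B' /\ Corr L None A0 B0
  | Some k => (exists d, a = ABOut k d) \/ (exists c, a = AIn k c) \/
              (a = ATau /\ exists A0 B' B0, trans B a B' /\ alpha A' A0 /\ alpha B0 B' /\ Corr L None A0 B0)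
  end.

Definition forward_claim (n : nat) : Prop :=
  forall A, size A <= n -> forall L pk B, Corr L pk A B ->
  forall A1 a A', alpha A A1 -> trans A1 a A' -> fw_side L a B -> fw_result pk L a A' B.

Lemma fw_side_res_rename L al k z B : fw_side L al (Res k B) -> ~ occurs_c z B ->
  fw_side (rem z L) al (mapc (swap k z) B).
Proof.
  intros [HL Hin] Hz. split.
  - intros l0 Hl0 Hf. rewrite in_rem in Hl0. rewrite fo_swap in Hf.
    destruct (Nat.eq_dec l0 k) as [->|Hl0k].
    + rewrite swap_l in Hf. apply Hz, free_occ, fo_free; auto.
    + rewrite swap_o in Hf by tauto. apply (HL l0); [tauto|]. simpl; auto.
  - intros k0 c0 Ea Hc. rewrite in_rem in Hc. apply (Hin k0 c0); tauto.
Qed.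

Lemma fw_side_prot_rename L al k z B : fw_side L al (Res k B) -> ~ occurs_c z B ->
  ~ fo k B -> ~ act_names al z -> fw_side (z :: rem z L) al (mapc (swap k z) B).
Proof.
  intros HC Hz Hfo Hza. destruct (fw_side_res_rename L al k z B HC Hz) as [HL Hin]. split.
  - intros l0 [<-|Hl0] Hf; [|exact (HL l0 Hl0 Hf)].
    rewrite fo_swap, swap_r in Hf. auto.
  - intros k0 c0 Ea [<-|Hc]; [subst; apply Hza; simpl; auto|exact (Hin k0 c0 Ea Hc)].
Qed.

Lemma trans_res_renamed k z B al B' : ~ occurs_c z B -> ~ act_names al z ->
  trans (mapc (swap k z) B) al B' -> trans (Res k B) al (Res z B').
Proof. intros Hz Hza Ht. eapply t_alpha; [apply (alpha_res_swap k z); auto|apply t_res; auto]. Qed.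

Lemma alpha_res_renamed k z P Q : ~ occurs_c z P -> alpha (mapc (swap k z) P) Q ->
  alpha (Res k P) (Res z Q).
Proof. intros Hz Ha. eapply al_trans; [apply (alpha_res_swap k z); auto|apply al_res; auto]. Qed.

Lemma trans_open_renamed k l l' z B B' : ~ occurs_c z B -> ~ free_chan l (Res l' B) ->
  z <> k -> z <> l -> l <> k -> trans (mapc (swap l' z) B) (AOut k z) B' ->
  trans (Res l' B) (ABOut k l) (mapc (swap z l) B').
Proof.
  intros Hz Hfl Hzk Hzl Hlk Ht. eapply t_alpha; [|apply t_open].
  - eapply al_trans; [apply (alpha_res_swap l' z); auto|].
    assert (Hsw : alpha (Res z (mapc (swap l' z) B)) (mapc (swap z l) (Res z (mapc (swap l' z) B)))).
    { apply alpha_swap_nonfree; simpl; [tauto|].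
      rewrite free_swap. destruct (Nat.eq_dec l l') as [<-|Hll'].
      - rewrite swap_l. intros [_ Hf]. apply Hz, free_occ; auto.
      - rewrite swap_o by (auto; intro; subst; tauto). intros [_ Hf]. apply Hfl. simpl; split; auto. }
    simpl in Hsw. rewrite swap_l in Hsw. exact Hsw.
  - apply (trans_swap z l) in Ht. simpl in Ht. rewrite swap_l, (swap_o z l k) in Ht by auto. exact Ht.
  - auto.
Qed.

Lemma res_fresh_body k P al P' k' P'' (cs : list chan) (Ps : list proc) :
  trans P al P' -> ~ act_names al k -> res_bodies_alpha k P k' P'' ->
  exists z, ~ In z cs /\ (forall R, In R Ps -> ~ occurs_c z R) /\ ~ occurs_c z P' /\
    ~ occurs_c z P'' /\ ~ act_names al z /\
    alpha (mapc (swap k' z) P'') (mapc (swap k z) P) /\ trans (mapc (swap k z) P) al (mapc (swap k z) P').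
Proof.
  intros Ht Hk Hsw.
  destruct (fresh_c (P :: P' :: P'' :: Ps) (k :: cs ++ act_chans al)) as [z [Hz1 Hz2]].
  simpl in Hz2; rewrite in_app_iff in Hz2.
  assert (Hza : ~ act_names al z) by (intro Hq; apply act_chans_in in Hq; tauto).
  exists z. split; [tauto|]. split; [intros R HR; apply Hz1; simpl; auto|].
  do 3 (split; [try exact Hza; apply Hz1; simpl; auto|]). split.
  - apply al_sym, Hsw; apply Hz1; simpl; auto.
  - apply (trans_swap k z) in Ht. rewrite mapa_id in Ht; auto.
    intros c Hc. apply swap_o; intro; subst; tauto.
Qed.

Lemma open_fresh_body k l P Q l' P'' (cs : list chan) (Ps : list proc) :
  trans P (AOut k l) Q -> k <> l -> res_bodies_alpha l P l' P'' ->
  exists z, ~ In z (k :: l :: cs) /\ (forall R, In R Ps -> ~ occurs_c z R) /\ ~ occurs_c z Q /\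
    ~ occurs_c z P'' /\ alpha (mapc (swap l' z) P'') (mapc (swap l z) P) /\
    trans (mapc (swap l z) P) (AOut k z) (mapc (swap l z) Q).
Proof.
  intros Ht Hkl Hsw.
  destruct (fresh_c (P :: Q :: P'' :: Ps) (k :: l :: cs)) as [z [Hz1 Hz2]].
  exists z. split; [exact Hz2|]. split; [intros R HR; apply Hz1; simpl; auto|].
  do 2 (split; [apply Hz1; simpl; auto|]). split.
  - apply al_sym, Hsw; apply Hz1; simpl; auto.
  - apply (trans_swap l z) in Ht. simpl in Ht.
    rewrite swap_l, (swap_o l z k) in Ht by (auto; intro; subst; simpl in Hz2; tauto). exact Ht.
Qed.

Lemma fw_side_extrude L k l B B' : fw_side L ATau B' -> (forall c, fo c B -> fo c B') ->
  fw_side (rem l L) (ABOut k l) B /\ fw_side (rem l L) (AIn k l) B.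
Proof.
  intros [HL _] Hsub.
  assert (HL' : forall l1, In l1 (rem l L) -> ~ fo l1 B)
    by (intros l1 Hl1 Hf; rewrite in_rem in Hl1; apply (HL l1); [tauto|auto]).
  split; split; auto; [discriminate|].
  intros k1 c1 Ea; inversion Ea; subst. rewrite in_rem; tauto.
Qed.

Section Forward.
Variable n : nat.
Hypothesis IHn : forward_claim n.

Definition fw_motive (A1 : proc) (a : act) (A' : proc) : Prop :=
  forall A0, size A0 <= S n -> forall L pk B, Corr L pk A0 B -> alpha A0 A1 ->
  fw_side L a B -> fw_result pk L a A' B.

Lemma fw_out (k l : chan) (P : proc) :
  fw_motive (Pre (POut (NC k) l) P) (AOut k l) P.
Proof.
  intros A0 Hs L pk B HE Ha HC.
  destruct (alpha_pre _ _ _ (al_sym _ _ Ha)) as [p' [P' [-> [[N [-> Hp]]|[x [x' [Hbv _]]]]]]];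
      [|discriminate].
  apply corr_inv_pre in HE.
  destruct HE as [-> [[B' [-> HE]]|[[c [d [q [Ep _]]]]|[m [y [l0 [q [y2 [Ep _]]]]]]]]]; try discriminate.
  simpl. exists P', B', B'. repeat split; [apply t_out|auto|apply al_refl|auto].
Qed.

Lemma fw_in (k : chan) (x : var) (l : chan) (P : proc) :
  ~ chan_bound l P ->
  fw_motive (Pre (PIn (NC k) x) P) (AIn k l) (subst P x l).
Proof.
  intros H A0 Hs L pk B HE Ha HC.
  destruct (alpha_pre _ _ _ (al_sym _ _ Ha)) as [p' [P' [-> [[N _]|[x0 [x' [Hbv [-> Hsw]]]]]]]];
      [discriminate|].
  simpl in Hbv; inversion Hbv; subst x0. simpl in *.
  apply corr_inv_pre in HE.
  destruct HE as [-> [[B' [-> HE]]|[[c [d [q [Ep _]]]]|[m [y [l0 [q [y2 [Ep [EA [-> Hl0]]]]]]]]]]];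
      try discriminate.
  + destruct (corr_avoid_bound _ _ _ _ l HE) as [P2 [B2 [H1 [H2 [H3 [H4 H5]]]]]].
    simpl. exists (subst P2 x' l), (subst B2 x' l), (subst B2 x' l). repeat split.
    * eapply t_alpha. apply al_pre; eauto. apply t_in; auto.
    * eapply input_subst_alpha; [|eauto|eauto]. eapply al_trans; [apply al_sym; exact Ha|].
        apply al_pre; auto.
    * apply al_refl.
    * apply corr_subst; auto. apply (proj2 HC k l); auto.
  + (* a guarded receiver gets a channel l different from the protected l0: the match fails *)
    inversion Ep; subst m y. subst P'.
    destruct (subst_match_nil x' l0 q l) as [q' Eq'].
    simpl. exists (Pre (PMatch (NC l) (NC l0) q') Nil), Nil, Nil. repeat split.
    * apply trans_recv_nil.
    * rewrite <- Eq'. eapply input_subst_alpha; [apply al_sym; exact Ha|auto|simpl; auto].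
    * apply al_refl.
    * apply corr_failed_match. intro; subst. apply (proj2 HC k l0 eq_refl); auto.
Qed.

Lemma fw_match (a : name) (p : prefix) (P : proc) (al : act) (P' : proc) :
  fw_motive (Pre p P) al P' ->
  fw_motive (Pre (PMatch a a p) P) al P'.
Proof.
  intros IHHt A0 Hs L pk B HE Ha HC.
  destruct (alpha_peel _ _ _ _ _ (al_sym _ _ Ha)) as [q' [R' [-> Hq]]].
  apply corr_inv_pre in HE.
  destruct HE as [-> [[B' [-> HE]]|[[c [d [q [Ep [-> [-> Hcd]]]]]]|[m [y [l0 [q [y2 [Ep _]]]]]]]]];
      try discriminate.
  + assert (Hs': size (Pre q' R') <= S n) by (simpl in *; lia).
    destruct (IHHt (Pre q' R') Hs' L None (Pre q' B') (corr_pre _ _ _ _ HE) (al_sym _ _ Hq) HC)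
      as [A0s [B's [B0s [Ht2 [Ha2 [Hb2 HE2]]]]]].
    simpl. exists A0s, B's, B0s. repeat split; auto. apply t_match; auto.
  + inversion Ep; subst. congruence.
Qed.

Lemma fw_res (k : chan) (P : proc) (al : act) (P' : proc) :
  trans P al P' -> ~ act_names al k -> fw_motive (Res k P) al (Res k P').
Proof.
  intros Ht Hk A0 Hs L pk B HE Ha HC.
  destruct (alpha_res _ _ _ (al_sym _ _ Ha)) as [k' [P'' [-> Hsw]]].
  apply corr_inv_res in HE. destruct HE as [-> HE].
  destruct HE as [[B' [-> HE]]|[[B' [-> [HE Hfo]]]|[[B' [-> HE]]|[W ->]]]].
  4:{ exfalso. eapply self_output_stuck; [apply t_res; eauto|apply al_sym; exact Ha]. }
  all: destruct (res_fresh_body k P al P' k' P'' L [B'] Ht Hk Hsw)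
         as [z [HzL [HzB [HzP' [HzP'' [Hza [Hsw' Ht']]]]]]].
  all: specialize (HzB B' (or_introl eq_refl)).
  all: assert (Hsz : size (mapc (swap k' z) P'') <= n) by (rewrite size_mapc; simpl in Hs; lia).
  all: simpl.
  -
    destruct (IHn _ Hsz (rem z L) None (mapc (swap k' z) B') (corr_res_rename L k' P'' B' z HE HzL)
      _ _ _ Hsw' Ht' (fw_side_res_rename L al k' z B' HC HzB)) as [A0s [B's [B0s [Ht2 [Ha2 [Hb2 HE2]]]]]].
    exists (Res z A0s), (Res z B's), (Res z B0s).
    repeat split; auto using trans_res_renamed, alpha_res_renamed, al_res, corr_res.
  - (* protected restriction: z stays protected, as it is not extruded *)
    destruct (IHn _ Hsz (z :: rem z L) None (mapc (swap k' z) B') (corr_prot_rename L k' P'' B' z HE HzL)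
      _ _ _ Hsw' Ht' (fw_side_prot_rename L al k' z B' HC HzB Hfo Hza))
      as [A0s [B's [B0s [Ht2 [Ha2 [Hb2 HE2]]]]]].
    exists (Res z A0s), (Res z B's), (Res z B0s).
    repeat split; auto using trans_res_renamed, alpha_res_renamed, al_res.
    apply corr_prot; auto. intro Hf. rewrite (alpha_fo _ _ _ Hb2) in Hf.
    destruct (trans_fo _ _ _ Ht2 z Hf) as [Hf2|Hf2].
    + rewrite fo_swap, swap_r in Hf2. auto.
    + apply Hza, act_bn_names; auto.
  - (* pending sender: the action cannot involve the private channel z *)
    pose proof (corr_mapc (swap k' z) _ _ _ _ (swap_inj k' z) HE) as HE'. simpl in HE'. rewrite swap_l in HE'.
    assert (HC' : fw_side [] al (mapc (swap k' z) B')) by (split; intros; simpl in *; tauto).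
    destruct (IHn _ Hsz [] (Some z) (mapc (swap k' z) B') HE' _ _ _ Hsw' Ht' HC')
      as [[d ->]|[[c0 ->]|[_ [A0s [B's [B0s [Ht2 [Ha2 [Hb2 HE2]]]]]]]]]; [simpl in Hza; tauto..|].
    exists (Res z A0s), (Res z B's), (Res z B0s).
    repeat split; auto using trans_res_renamed, alpha_res_renamed, al_res.
    apply corr_res. eapply corr_protected; eauto. simpl; tauto.
Qed.

Lemma fw_open (k l : chan) (P Q : proc) :
  trans P (AOut k l) Q -> k <> l -> fw_motive (Res l P) (ABOut k l) Q.
Proof.
  intros Ht Hkl A0 Hs L pk B HE Ha HC.
  destruct (alpha_res _ _ _ (al_sym _ _ Ha)) as [l' [P'' [-> Hsw]]].
  pose proof HE as HE0.
  apply corr_inv_res in HE. destruct HE as [-> HE].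
  destruct HE as [[B' [-> HE]]|[[B' [-> [HE Hfo]]]|[[B' [-> HE]]|[W ->]]]].
  4:{ exfalso. eapply self_output_stuck; [apply t_open; eauto|apply al_sym; exact Ha]. }
  all: destruct (open_fresh_body k l P Q l' P'' L [B'] Ht Hkl Hsw)
         as [z [Hz [HzB [HzQ [HzP'' [Hsw' Ht']]]]]].
  all: specialize (HzB B' (or_introl eq_refl)); simpl in Hz.
  all: assert (Hsz : size (mapc (swap l' z) P'') <= n) by (rewrite size_mapc; simpl in Hs; lia).
  -
    assert (HC' : fw_side (rem z L) (AOut k z) (mapc (swap l' z) B')).
    { destruct (fw_side_res_rename L _ l' z B' HC HzB) as [HL _]. split; [exact HL|discriminate]. }
    destruct (IHn _ Hsz (rem z L) None (mapc (swap l' z) B') (corr_res_rename L l' P'' B' z HE ltac:(tauto))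
      _ _ _ Hsw' Ht' HC') as [A0s [B's [B0s [Ht2 [Ha2 [Hb2 HE2]]]]]].
    assert (Hfl : ~ free_chan l (Res l' B')).
    { intro Hf. apply (corr_free _ _ _ _ _ HE0) in Hf. rewrite (alpha_free _ _ _ Ha) in Hf.
        simpl in Hf; tauto. }
    simpl. exists (mapc (swap z l) A0s), (mapc (swap z l) B's), (mapc (swap z l) B0s). repeat split.
    + apply trans_open_renamed; auto; intro; subst; tauto.
    + apply (alpha_swap l z) in Ha2. rewrite swap_mapc_inv in Ha2. rewrite mapc_swap_sym. exact Ha2.
    + apply alpha_swap; auto.
    + pose proof (corr_mapc (swap z l) _ _ _ _ (swap_inj z l) HE2) as HE3. simpl in HE3.
      eapply corr_protected; eauto. intros c Hc Hf. apply in_map_iff in Hc. destruct Hc as [c0 [<- Hc]].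
      rewrite in_rem in Hc. destruct Hc as [Hc Hc'].
      destruct (Nat.eq_dec c0 l) as [->|Hc0l]; [exfalso|rewrite swap_o by auto; auto].
      rewrite swap_r, free_swap, swap_l, <- (alpha_free _ _ _ Ha2), free_swap, swap_l in Hf.
      apply HzQ, free_occ; auto.
  - (* protected restriction: impossible, the extruded channel would be an output object *)
    assert (HC' : fw_side (z :: rem z L) (AOut k z) (mapc (swap l' z) B')).
    { destruct (fw_side_prot_rename L (ABOut k l) l' z B' HC HzB Hfo) as [HL _];
        [simpl; intuition congruence|split; [exact HL|discriminate]]. }
    destruct (IHn _ Hsz (z :: rem z L) None (mapc (swap l' z) B') (corr_prot_rename L l' P'' B' z
        HE ltac:(tauto))
      _ _ _ Hsw' Ht' HC') as [A0s [B's [B0s [Ht2 _]]]].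
    exfalso. pose proof (trans_out_fo _ _ _ Ht2 k z eq_refl) as Hf. rewrite fo_swap, swap_r in Hf. auto.
  - (* pending sender: a free output on its private channel is impossible *)
    pose proof (corr_mapc (swap l' z) _ _ _ _ (swap_inj l' z) HE) as HE'. simpl in HE'. rewrite swap_l in HE'.
    assert (HC' : fw_side [] (AOut k z) (mapc (swap l' z) B')) by (split; intros; simpl in *; tauto).
    destruct (IHn _ Hsz [] (Some z) (mapc (swap l' z) B') HE' _ _ _ Hsw' Ht' HC')
      as [[d Ed]|[[c0 Ec]|[Et _]]]; discriminate.
Qed.

Lemma fw_parl (P Q R : proc) (al : act) :
  trans P al Q ->
  fw_motive P al Q ->
  (forall c, act_bn al c -> ~ free_chan c R) ->
  fw_motive (Par P R) al (Par Q R).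
Proof.
  intros Ht IHHt H A0 Hs L pk B HE Ha HC.
  destruct (alpha_par_r _ _ _ Ha) as [P0 [R0 [-> [HP HR]]]].
  apply corr_inv_par in HE.
  destruct HE as [[-> [B1 [B2 [-> [HE1 HE2]]]]]|[k [l [mm [y [q [B2 [-> [-> [-> [-> [Hm [Hkl [HE2
      HI]]]]]]]]]]]]]].
  + assert (Hs1: size P0 <= S n) by (simpl in Hs; lia).
    assert (HC1: fw_side L al B1) by (destruct HC as [HC1 HC2]; split; auto; intros l0 Hl0 Hf;
        apply (HC1 l0 Hl0); simpl; auto).
    destruct (IHHt P0 Hs1 L None B1 HE1 HP HC1) as [A0s [B's [B0s [Ht2 [Ha2 [Hb2 HE3]]]]]].
    simpl. exists (Par A0s R0), (Par B's B2), (Par B0s B2). repeat split.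
    * apply t_parl; auto. intros c Hc Hf. apply (H c Hc). rewrite <- (alpha_free _ _ _ HR).
        eapply corr_free; eauto.
    * apply al_par; auto. apply al_sym; auto.
    * apply al_par; auto; apply al_refl.
    * apply corr_par; auto.
  + simpl. left. destruct (sender_trans_inv _ _ _ Ht l k mm y q (al_sym _ _ HP) Hkl Hm) as [d [Ed _]]. eauto.
Qed.

Lemma fw_parr (P Q R : proc) (al : act) :
  trans P al Q ->
  fw_motive P al Q ->
  (forall c, act_bn al c -> ~ free_chan c R) ->
  fw_motive (Par R P) al (Par R Q).
Proof.
  intros Ht IHHt H A0 Hs L pk B HE Ha HC.
  destruct (alpha_par_r _ _ _ Ha) as [R0 [P0 [-> [HR HP]]]].
  apply corr_inv_par in HE.
  destruct HE as [[-> [B1 [B2 [-> [HE1 HE2]]]]]|[k [l [mm [y [q [B2 [-> [-> [-> [-> [Hm [Hkl [HE2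
      HI]]]]]]]]]]]]]].
  + assert (Hs1: size P0 <= S n) by (simpl in Hs; lia).
    assert (HC1: fw_side L al B2) by (destruct HC as [HC1 HC2]; split; auto; intros l0 Hl0 Hf;
        apply (HC1 l0 Hl0); simpl; auto).
    destruct (IHHt P0 Hs1 L None B2 HE2 HP HC1) as [A0s [B's [B0s [Ht2 [Ha2 [Hb2 HE3]]]]]].
    simpl. exists (Par R0 A0s), (Par B1 B's), (Par B1 B0s). repeat split.
    * apply t_parr; auto. intros c Hc Hf. apply (H c Hc). rewrite <- (alpha_free _ _ _ HR).
        eapply corr_free; eauto.
    * apply al_par; auto. apply al_sym; auto.
    * apply al_par; auto; apply al_refl.
    * apply corr_par; auto.
  + simpl. right; left. destruct HI as [x [W ->]]. exact (inp_inv _ _ _ Ht k x W (al_sym _ _ HP)).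
Qed.

Lemma fw_comml (P P' Q Q' : proc) (k l : chan) :
  trans P (AOut k l) P' ->
  fw_motive P (AOut k l) P' ->
  fw_motive Q (AIn k l) Q' ->
  fw_motive (Par P Q) ATau (Par P' Q').
Proof.
  intros Ht1 IHHt1 IHHt2 A0 Hs L pk B HE Ha HC.
  destruct (alpha_par_r _ _ _ Ha) as [P0 [Q0 [-> [HP HQ]]]].
  apply corr_inv_par in HE.
  destruct HE as [[-> [B1 [B2 [-> [HE1 HE2]]]]]|[k0 [l0 [mm [y [q [B2 [-> [-> [-> [-> [Hm [Hkl [HE2
      HI]]]]]]]]]]]]]].
  + assert (Hs1: size P0 <= S n) by (simpl in Hs; lia).
    assert (Hs2: size Q0 <= S n) by (simpl in Hs; lia).
    assert (HC1: fw_side L (AOut k l) B1) by (destruct HC as [HC1 HC2]; split; [intros l1 Hl1 Hf;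
        apply (HC1 l1 Hl1); simpl; auto|intros; discriminate]).
    destruct (IHHt1 P0 Hs1 L None B1 HE1 HP HC1) as [A0p [B'p [B0p [Htp [Hap [Hbp HEp]]]]]].
    assert (Hl: ~ In l L) by (intro Hl; apply (proj1 HC l Hl); simpl; left; eapply trans_out_fo; eauto).
    assert (HC2: fw_side L (AIn k l) B2).
    { destruct HC as [HC1' HC2']; split; [intros l1 Hl1 Hf; apply (HC1' l1 Hl1); simpl;
        auto|intros k1 c1 Ea; inversion Ea; subst; auto]. }
    destruct (IHHt2 Q0 Hs2 L None B2 HE2 HQ HC2) as [A0q [B'q [B0q [Htq [Haq [Hbq HEq]]]]]].
    simpl. exists (Par A0p A0q), (Par B'p B'q), (Par B0p B0q). repeat split.
    * eapply t_comml; eauto.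
    * apply al_par; auto.
    * apply al_par; auto.
    * apply corr_par; auto.
  + exfalso. destruct (sender_trans_inv _ _ _ Ht1 l0 k0 mm y q (al_sym _ _ HP) Hkl Hm) as [d [Ed
      _]]. discriminate.
Qed.

Lemma fw_commr (P P' Q Q' : proc) (k l : chan) :
  trans P (AIn k l) P' ->
  fw_motive P (AIn k l) P' ->
  fw_motive Q (AOut k l) Q' ->
  fw_motive (Par P Q) ATau (Par P' Q').
Proof.
  intros Ht1 IHHt1 IHHt2 A0 Hs L pk B HE Ha HC.
  destruct (alpha_par_r _ _ _ Ha) as [P0 [Q0 [-> [HP HQ]]]].
  apply corr_inv_par in HE.
  destruct HE as [[-> [B1 [B2 [-> [HE1 HE2]]]]]|[k0 [l0 [mm [y [q [B2 [-> [-> [-> [-> [Hm [Hkl [HE2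
      HI]]]]]]]]]]]]]].
  + assert (Hs1: size P0 <= S n) by (simpl in Hs; lia).
    assert (Hs2: size Q0 <= S n) by (simpl in Hs; lia).
    assert (HC2: fw_side L (AOut k l) B2) by (destruct HC as [HC1 HC2]; split; [intros l1 Hl1 Hf;
        apply (HC1 l1 Hl1); simpl; auto|intros; discriminate]).
    destruct (IHHt2 Q0 Hs2 L None B2 HE2 HQ HC2) as [A0q [B'q [B0q [Htq [Haq [Hbq HEq]]]]]].
    assert (Hl: ~ In l L) by (intro Hl; apply (proj1 HC l Hl); simpl; right; eapply trans_out_fo; eauto).
    assert (HC1: fw_side L (AIn k l) B1).
    { destruct HC as [HC1' HC2']; split; [intros l1 Hl1 Hf; apply (HC1' l1 Hl1); simpl;
        auto|intros k1 c1 Ea; inversion Ea; subst; auto]. }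
    destruct (IHHt1 P0 Hs1 L None B1 HE1 HP HC1) as [A0p [B'p [B0p [Htp [Hap [Hbp HEp]]]]]].
    simpl. exists (Par A0p A0q), (Par B'p B'q), (Par B0p B0q). repeat split.
    * eapply t_commr; eauto.
    * apply al_par; auto.
    * apply al_par; auto.
    * apply corr_par; auto.
  + exfalso. destruct (sender_trans_inv _ _ _ Ht1 l0 k0 mm y q (al_sym _ _ HP) Hkl Hm) as [d [Ed
      _]]. discriminate.
Qed.

(* Both sides close the
   scope of l, the receivers become m(y).[y=l]q.0 and m(y).0, and l is protected from
   then on, since the partner cannot output the received channel. *)
Lemma fw_close_sender P P' Q Q' k l k0 l0 mm y q Q0 B2 :
  trans P (ABOut k l) P' -> fw_motive Q (AIn k l) Q' -> ~ free_chan l Q ->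
  alpha (sender l0 (Some k0) mm y q) P -> alpha Q0 Q -> size Q0 <= S n ->
  mm <> Some l0 -> k0 <> l0 -> Corr [] None Q0 B2 ->
  fw_result (Some k0) [] ATau (Res l (Par P' Q')) (Par (sender_nil l0 (Some k0) mm y) B2).
Proof.
  intros Ht1 IHHt2 H HP HQ Hs2 Hm Hkl HE2.
  destruct (sender_trans_inv _ _ _ Ht1 l0 k0 mm y q (al_sym _ _ HP) Hkl Hm) as [d [Ed [Hkd [Hmd [q' Hq']]]]].
  inversion Ed; subst k0 d.
  assert (HC2 : fw_side [] (AIn k l) B2) by (split; intros; simpl in *; tauto).
  destruct (IHHt2 Q0 Hs2 [] None B2 HE2 HQ HC2) as [A0q [B'q [B0q [Htq [Haq [Hbq HEq]]]]]].
  assert (HlB2 : ~ free_chan l B2)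
    by (intro Hf; apply (corr_free _ _ _ _ _ HE2) in Hf; rewrite (alpha_free _ _ _ HQ) in Hf; auto).
  simpl. right; right. split; auto.
  exists (Res l (Par (recv_match l (odflt l mm) y q') A0q)), (Res l (Par (recv_nil (odflt l mm) y) B'q)),
         (Res l (Par (recv_nil (odflt l mm) y) B0q)). repeat split.
  - eapply t_closel; [|exact Htq|auto].
    destruct (Nat.eq_dec l l0) as [<-|Hll0]; [apply sender_nil_open; auto|].
    eapply t_alpha; [|apply sender_nil_open; auto].
    apply (sender_nil_rename l0 (Some k) mm y l); try congruence.
    intro Ho; apply occ_sender_nil_body in Ho; simpl in Ho.
    destruct Ho as [Ho|[Ho|Ho]]; [congruence|congruence|].
    destruct mm; simpl in Ho; subst; congruence.
  - apply al_res, al_par; auto.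
  - apply al_res, al_par; [apply al_refl|auto].
  - apply corr_prot.
    + simpl. apply corr_par; [apply corr_recv; simpl; auto|]. eapply corr_protected; eauto. simpl; tauto.
    + intro Hf. simpl in Hf. destruct Hf as [Hf|Hf]; [unfold recv_nil in Hf; simpl in Hf; tauto|].
      rewrite (alpha_fo _ _ _ Hbq) in Hf.
          destruct (trans_fo _ _ _ Htq l Hf) as [Hf2|Hf2]; [|simpl in Hf2; tauto].
      apply HlB2, fo_free; auto.
Qed.

Lemma fw_closel (P P' Q Q' : proc) (k l : chan) :
  trans P (ABOut k l) P' ->
  fw_motive P (ABOut k l) P' ->
  fw_motive Q (AIn k l) Q' ->
  ~ free_chan l Q ->
  fw_motive (Par P Q) ATau (Res l (Par P' Q')).
Proof.
  intros Ht1 IHHt1 IHHt2 H A0 Hs L pk B HE Ha HC.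
  destruct (alpha_par_r _ _ _ Ha) as [P0 [Q0 [-> [HP HQ]]]].
  apply corr_inv_par in HE.
  destruct HE as [[-> [B1 [B2 [-> [HE1 HE2]]]]]|[k0 [l0 [mm [y [q [B2 [-> [-> [-> [-> [Hm [Hkl [HE2
      HI]]]]]]]]]]]]]];
    [|apply (fw_close_sender P P' Q Q' k l k0 l0 mm y q Q0 B2); auto; simpl in Hs; lia].
  assert (Hs1 : size P0 <= S n) by (simpl in Hs; lia).
  assert (Hs2 : size Q0 <= S n) by (simpl in Hs; lia).
  destruct (trans_bout_fresh _ _ _ Ht1 k l eq_refl) as [Hkl' Hfp].
  assert (Hfp0 : ~ free_chan l P0) by (rewrite (alpha_free _ _ _ HP); auto).
  assert (Hfq0 : ~ free_chan l Q0) by (rewrite (alpha_free _ _ _ HQ); auto).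
  destruct (fw_side_extrude L k l B1 (Par B1 B2) HC) as [HC1 _]; [simpl; auto|].
  destruct (fw_side_extrude L k l B2 (Par B1 B2) HC) as [_ HC2]; [simpl; auto|].
  destruct (IHHt1 P0 Hs1 _ None B1 (corr_unprotect _ _ _ _ HE1 Hfp0) HP HC1)
    as [A0p [B'p [B0p [Htp [Hap [Hbp HEp]]]]]].
  destruct (IHHt2 Q0 Hs2 _ None B2 (corr_unprotect _ _ _ _ HE2 Hfq0) HQ HC2)
    as [A0q [B'q [B0q [Htq [Haq [Hbq HEq]]]]]].
  simpl. exists (Res l (Par A0p A0q)), (Res l (Par B'p B'q)), (Res l (Par B0p B0q)). repeat split.
  - eapply t_closel; eauto. intro Hf. apply Hfq0. eapply corr_free; eauto.
  - apply al_res, al_par; auto.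
  - apply al_res, al_par; auto.
  - apply corr_res, corr_par; auto.
Qed.

Lemma fw_closer (P P' Q Q' : proc) (k l : chan) :
  trans P (AIn k l) P' ->
  fw_motive P (AIn k l) P' ->
  trans Q (ABOut k l) Q' ->
  fw_motive Q (ABOut k l) Q' ->
  ~ free_chan l P ->
  fw_motive (Par P Q) ATau (Res l (Par P' Q')).
Proof.
  intros Ht1 IHHt1 Ht2 IHHt2 H A0 Hs L pk B HE Ha HC.
  destruct (alpha_par_r _ _ _ Ha) as [P0 [Q0 [-> [HP HQ]]]].
  apply corr_inv_par in HE.
  destruct HE as [[-> [B1 [B2 [-> [HE1 HE2]]]]]|[k0 [l0 [mm [y [q [B2 [-> [-> [-> [-> [Hm [Hkl [HE2
      HI]]]]]]]]]]]]]].
  - assert (Hs1 : size P0 <= S n) by (simpl in Hs; lia).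
    assert (Hs2 : size Q0 <= S n) by (simpl in Hs; lia).
    destruct (trans_bout_fresh _ _ _ Ht2 k l eq_refl) as [Hkl' Hfq].
    assert (Hfp0 : ~ free_chan l P0) by (rewrite (alpha_free _ _ _ HP); auto).
    assert (Hfq0 : ~ free_chan l Q0) by (rewrite (alpha_free _ _ _ HQ); auto).
    destruct (fw_side_extrude L k l B1 (Par B1 B2) HC) as [_ HC1]; [simpl; auto|].
    destruct (fw_side_extrude L k l B2 (Par B1 B2) HC) as [HC2 _]; [simpl; auto|].
    destruct (IHHt1 P0 Hs1 _ None B1 (corr_unprotect _ _ _ _ HE1 Hfp0) HP HC1)
      as [A0p [B'p [B0p [Htp [Hap [Hbp HEp]]]]]].
    destruct (IHHt2 Q0 Hs2 _ None B2 (corr_unprotect _ _ _ _ HE2 Hfq0) HQ HC2)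
      as [A0q [B'q [B0q [Htq [Haq [Hbq HEq]]]]]].
    simpl. exists (Res l (Par A0p A0q)), (Res l (Par B'p B'q)), (Res l (Par B0p B0q)). repeat split.
    + eapply t_closer; eauto. intro Hf. apply Hfp0. eapply corr_free; eauto.
    + apply al_res, al_par; auto.
    + apply al_res, al_par; auto.
    + apply corr_res, corr_par; auto.
  - (* the pending sender cannot perform an input *)
    exfalso. destruct (sender_trans_inv _ _ _ Ht1 l0 k0 mm y q (al_sym _ _ HP) Hkl Hm) as [d [Ed _]].
    discriminate.
Qed.

Lemma fw_rep_act (P P' : proc) (al : act) :
  fw_motive P al P' ->
  fw_motive (Rep P) al (Par P' (Rep P)).
Proof.
  intros IHHt A0 Hs L pk B HE Ha HC.
  destruct (alpha_rep_r _ _ Ha) as [P0 [-> HP]].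
  apply corr_inv_rep in HE. destruct HE as [-> [B' [-> HE]]].
  assert (Hs1: size P0 <= S n) by (simpl in Hs; lia).
  destruct (IHHt P0 Hs1 L None B' HE HP HC) as [A0s [B's [B0s [Ht2 [Ha2 [Hb2 HE3]]]]]].
  simpl. exists (Par A0s (Rep P0)), (Par B's (Rep B')), (Par B0s (Rep B')). repeat split.
  * apply t_rep_act; auto.
  * apply al_par; auto. apply al_rep, al_sym; auto.
  * apply al_par; auto; apply al_refl.
  * apply corr_par; auto. apply corr_rep; auto.
Qed.

Lemma fw_rep_comm (P P' P'' : proc) (k l : chan) :
  fw_motive P (AOut k l) P' ->
  fw_motive P (AIn k l) P'' ->
  fw_motive (Rep P) ATau (Par (Par P' P'') (Rep P)).
Proof.
  intros IHHt1 IHHt2 A0 Hs L pk B HE Ha HC.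
  destruct (alpha_rep_r _ _ Ha) as [P0 [-> HP]].
  apply corr_inv_rep in HE. destruct HE as [-> [B' [-> HE]]].
  assert (Hs1: size P0 <= S n) by (simpl in Hs; lia).
  assert (HC1: fw_side L (AOut k l) B') by (destruct HC as [HC1 HC2]; split; auto; intros; discriminate).
  destruct (IHHt1 P0 Hs1 L None B' HE HP HC1) as [A0a [B'a [B0a [Hta [Haa [Hba HEa]]]]]].
  assert (Hl: ~ In l L) by (intro Hl; apply (proj1 HC l Hl); simpl; eapply trans_out_fo; eauto).
  assert (HC2: fw_side L (AIn k l) B') by (destruct HC as [HC1' HC2']; split; auto;
      intros k1 c1 Ea; inversion Ea; subst; auto).
  destruct (IHHt2 P0 Hs1 L None B' HE HP HC2) as [A0b [B'b [B0b [Htb [Hab [Hbb HEb]]]]]].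
  simpl. exists (Par (Par A0a A0b) (Rep P0)), (Par (Par B'a B'b) (Rep B')),
      (Par (Par B0a B0b) (Rep B')). repeat split.
  * eapply t_rep_comm; eauto.
  * apply al_par; [apply al_par; auto|apply al_rep, al_sym; auto].
  * apply al_par; [apply al_par; auto|apply al_refl].
  * apply corr_par; [apply corr_par; auto|apply corr_rep; auto].
Qed.

Lemma fw_rep_close (P P' P'' : proc) (k l : chan) :
  fw_motive P (ABOut k l) P' ->
  fw_motive P (AIn k l) P'' ->
  ~ free_chan l P ->
  fw_motive (Rep P) ATau (Par (Res l (Par P' P'')) (Rep P)).
Proof.
  intros IHHt1 IHHt2 H A0 Hs L pk B HE Ha HC.
  destruct (alpha_rep_r _ _ Ha) as [P0 [-> HP]].
  apply corr_inv_rep in HE. destruct HE as [-> [B' [-> HE]]].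
  assert (Hs1 : size P0 <= S n) by (simpl in Hs; lia).
  assert (Hfp0 : ~ free_chan l P0) by (rewrite (alpha_free _ _ _ HP); auto).
  destruct (fw_side_extrude L k l B' (Rep B') HC) as [HC1 HC2]; [simpl; auto|].
  pose proof (corr_unprotect _ _ _ _ HE Hfp0) as HE'.
  destruct (IHHt1 P0 Hs1 _ None B' HE' HP HC1) as [A0a [B'a [B0a [Hta [Haa [Hba HEa]]]]]].
  destruct (IHHt2 P0 Hs1 _ None B' HE' HP HC2) as [A0b [B'b [B0b [Htb [Hab [Hbb HEb]]]]]].
  simpl. exists (Par (Res l (Par A0a A0b)) (Rep P0)), (Par (Res l (Par B'a B'b)) (Rep B')),
    (Par (Res l (Par B0a B0b)) (Rep B')). repeat split.
  - eapply t_rep_close; eauto. intro Hf. apply Hfp0. eapply corr_free; eauto.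
  - apply al_par; [apply al_res, al_par; auto|apply al_rep, al_sym; auto].
  - apply al_par; [apply al_res, al_par; auto|apply al_refl].
  - apply corr_par; [apply corr_res, corr_par; auto|apply corr_rep; auto].
Qed.

Lemma fw_alpha (P P' : proc) (al : act) (Q : proc) :
  alpha P P' ->
  fw_motive P' al Q ->
  fw_motive P al Q.
Proof.
  intros H IHHt A0 Hs L pk B HE Ha HC.
  eapply IHHt; eauto. eapply al_trans; eauto.
Qed.

Lemma fw_step A1 a A' : trans A1 a A' -> fw_motive A1 a A'.
Proof.
  induction 1; eauto using fw_out, fw_in, fw_match, fw_res, fw_open, fw_parl, fw_parr, fw_comml,
    fw_commr, fw_closel, fw_closer, fw_rep_act, fw_rep_comm, fw_rep_close, fw_alpha.
Qed.
End Forward.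

Lemma forward_sim n : forward_claim n.
Proof.
  induction n as [|n IHn]; intros A Hs L pk B HE A1 a A' Ha Ht HC.
  - pose proof (size_pos A); lia.
  - eapply fw_step; eauto.
Qed.

Lemma corr_inv_par_r L pk A B1 B2 : Corr L pk A (Par B1 B2) ->
  (pk = None /\ exists A1 A2, A = Par A1 A2 /\ Corr L None A1 B1 /\ Corr L None A2 B2) \/
  (exists k l mm y q A2, pk = Some k /\ L = [] /\ B1 = sender_nil l (Some k) mm y /\
     A = Par (sender l (Some k) mm y q) A2 /\ mm <> Some l /\ k <> l /\ Corr [] None A2 B2 /\
         input_form k A2).
Proof. intros H; inversion H; subst.
  - left; split; auto; eauto.
  - right; do 6 eexists; repeat split; eauto.
Qed.

Lemma corr_inv_res_r L pk k A B : Corr L pk A (Res k B) -> pk = None /\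
  ((exists A', A = Res k A' /\ Corr (rem k L) None A' B) \/
   (exists A', A = Res k A' /\ Corr (k :: rem k L) None A' B /\ ~ fo k B) \/
   (exists A', A = Res k A' /\ Corr [] (Some k) A' B) \/
   (exists W, B = Pre (POut (NC k) k) W)).
Proof. intros H; inversion H; subst; split; auto.
  - left; eauto.
  - right; left; eauto.
  - right; right; right. eauto.
  - right; right; left; eauto.
Qed.

Lemma corr_inv_pre_r L pk A p B : Corr L pk A (Pre p B) -> pk = None /\
  ((exists A', A = Pre p A' /\ Corr L None A' B) \/
   (exists m y2 l y q, p = PIn (NC m) y2 /\ B = Nil /\ A = recv_match l m y q /\ In l L)).
Proof. intros H; inversion H; subst; split; auto.
  - left; eauto.
  - right. do 5 eexists; repeat split; eauto.
Qed.

Lemma corr_inv_rep_r L pk A B : Corr L pk A (Rep B) -> pk = None /\ exists A', A = Rep A' /\ Corr L None A' B.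
Proof. intros H; inversion H; subst; split; eauto. Qed.

(* The side conditions now also require the name extruded by B to be fresh for A, as
   granted by the definition of bisimulation. *)
Definition bw_side (L : list chan) (a : act) (A B : proc) :=
  fw_side L a B /\ (forall c, act_bn a c -> ~ free_chan c A).

Definition bw_result (pk : option chan) (L : list chan) (a : act) (A B' : proc) :=
  match pk with
  | None => exists A' A0 B0, trans A a A' /\ alpha A' A0 /\ alpha B0 B' /\ Corr L None A0 B0
  | Some k => (exists d, a = ABOut k d) \/ (exists c, a = AIn k c) \/
              (a = ATau /\ exists A' A0 B0, trans A a A' /\ alpha A' A0 /\ alpha B0 B' /\ Corr L None A0 B0)
  end.

Definition backward_claim (n : nat) : Prop :=
  forall B, size B <= n -> forall L pk A, Corr L pk A B ->
  forall B1 a B', alpha B B1 -> trans B1 a B' -> bw_side L a A B -> bw_result pk L a A B'.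

Lemma bn_not_free_res_rename al k z A : (forall c, act_bn al c -> ~ free_chan c (Res k A)) ->
  ~ occurs_c z A -> ~ act_names al z -> forall c, act_bn al c -> ~ free_chan c (mapc (swap k z) A).
Proof.
  intros Hbn Hz Hza c Hc Hf. rewrite free_swap in Hf.
  destruct (Nat.eq_dec c k) as [->|Hck].
  - rewrite swap_l in Hf. apply Hz, free_occ; auto.
  - rewrite swap_o in Hf by (auto; intro; subst; apply Hza, act_bn_names; auto).
    apply (Hbn c Hc). simpl; auto.
Qed.

Lemma bw_side_res_rename L al k z A B : bw_side L al (Res k A) (Res k B) ->
  ~ occurs_c z A -> ~ occurs_c z B -> ~ act_names al z ->
  bw_side (rem z L) al (mapc (swap k z) A) (mapc (swap k z) B).
Proof.
  intros [HC Hbn] HzA HzB Hza.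
  split; [apply fw_side_res_rename|apply bn_not_free_res_rename]; auto.
Qed.

Lemma bw_side_prot_rename L al k z A B : bw_side L al (Res k A) (Res k B) ->
  ~ occurs_c z A -> ~ occurs_c z B -> ~ fo k B -> ~ act_names al z ->
  bw_side (z :: rem z L) al (mapc (swap k z) A) (mapc (swap k z) B).
Proof.
  intros [HC Hbn] HzA HzB Hfo Hza.
  split; [apply fw_side_prot_rename|apply bn_not_free_res_rename]; auto.
Qed.

Lemma extrusion_fresh k l P P' Q Q' PB QB (Ps : list proc) (cs : list chan) :
  trans P (ABOut k l) P' -> trans Q (AIn k l) Q' -> ~ free_chan l Q -> alpha PB P -> alpha QB Q ->
  exists z, ~ In z (k :: l :: cs) /\ (forall R, In R Ps -> ~ occurs_c z R) /\
    alpha PB (mapc (swap l z) P) /\ alpha QB (mapc (swap l z) Q) /\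
    trans (mapc (swap l z) P) (ABOut k z) (mapc (swap l z) P') /\
    trans (mapc (swap l z) Q) (AIn k z) (mapc (swap l z) Q').
Proof.
  intros Ht1 Ht2 Hfq HP HQ.
  destruct (trans_bout_fresh _ _ _ Ht1 k l eq_refl) as [Hkl Hfp].
  destruct (fresh_c (P :: Q :: Ps) (k :: l :: cs)) as [z [Hz1 Hz2]].
  assert (HzP : ~ occurs_c z P) by (apply Hz1; simpl; auto).
  assert (HzQ : ~ occurs_c z Q) by (apply Hz1; simpl; auto).
  assert (Hkz : k <> z) by (intro; subst; simpl in Hz2; tauto).
  exists z. split; [exact Hz2|]. split; [intros R HR; apply Hz1; simpl; auto|].
  split; [eapply al_trans; [exact HP|apply alpha_swap_nonfree; auto; intro Hf; apply HzP, free_occ; auto]|].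
  split; [eapply al_trans; [exact HQ|apply alpha_swap_nonfree; auto; intro Hf; apply HzQ, free_occ; auto]|].
  split.
  - apply (trans_swap l z) in Ht1. simpl in Ht1. rewrite swap_l, (swap_o l z k) in Ht1 by auto. exact Ht1.
  - apply (trans_swap l z) in Ht2. simpl in Ht2. rewrite swap_l, (swap_o l z k) in Ht2 by auto. exact Ht2.
Qed.

Lemma bw_side_extrude L k z A B B' : fw_side L ATau B' -> (forall c, fo c B -> fo c B') ->
  ~ In z L -> ~ occurs_c z A -> bw_side L (ABOut k z) A B /\ bw_side L (AIn k z) A B.
Proof.
  intros [HL _] Hsub HzL HzA.
  assert (HL' : forall l1, In l1 L -> ~ fo l1 B) by (intros l1 Hl1 Hf; apply (HL l1); auto).
  split; split; [split; auto; discriminate| |split; auto| ].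
  - intros c Hc; simpl in Hc; subst. intro Hf; apply HzA, free_occ; auto.
  - intros k1 c1 Ea; inversion Ea; subst; auto.
  - intros c Hc; simpl in Hc; tauto.
Qed.

Section Backward.
Variable n : nat.
Hypothesis IHn : backward_claim n.

Definition bw_motive (B1 : proc) (a : act) (B' : proc) : Prop :=
  forall B0, size B0 <= S n -> forall L pk A0, Corr L pk A0 B0 -> alpha B0 B1 ->
  bw_side L a A0 B0 -> bw_result pk L a A0 B'.

Lemma bw_out (k l : chan) (P : proc) :
  bw_motive (Pre (POut (NC k) l) P) (AOut k l) P.
Proof.
  intros B0 Hs L pk A0 HE Ha HC.
  destruct (alpha_pre _ _ _ (al_sym _ _ Ha)) as [p' [P' [-> [[N [-> Hp]]|[x [x' [Hbv _]]]]]]];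
      [|discriminate].
  apply corr_inv_pre_r in HE.
  destruct HE as [-> [[A' [-> HE]]|[m [y2 [l0 [y [q [Ep _]]]]]]]]; try discriminate.
  simpl. exists A', A', P'. repeat split; [apply t_out|apply al_refl|apply al_sym; auto|auto].
Qed.

Lemma bw_in (k : chan) (x : var) (l : chan) (P : proc) :
  ~ chan_bound l P ->
  bw_motive (Pre (PIn (NC k) x) P) (AIn k l) (subst P x l).
Proof.
  intros H B0 Hs L pk A0 HE Ha HC.
  destruct (alpha_pre _ _ _ (al_sym _ _ Ha)) as [p' [P' [-> [[N _]|[x0 [x' [Hbv [-> Hsw]]]]]]]];
      [discriminate|].
  simpl in Hbv; inversion Hbv; subst x0. simpl in *.
  apply corr_inv_pre_r in HE.
  destruct HE as [-> [[A' [-> HE]]|[m [y2 [l0 [y [q [Ep [-> [-> Hl0]]]]]]]]]].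
  + destruct (corr_avoid_bound _ _ _ _ l HE) as [A2 [P2 [H1 [H2 [H3 [H4 H5]]]]]].
    simpl. exists (subst A2 x' l), (subst A2 x' l), (subst P2 x' l). repeat split.
    * eapply t_alpha. apply al_pre; eauto. apply t_in; auto.
    * apply al_refl.
    * eapply input_subst_alpha; [|eauto|eauto]. eapply al_trans; [|exact Ha]. apply al_pre, al_sym; auto.
    * apply corr_subst; auto. apply (proj2 (proj1 HC) k l); auto.
  + (* m(y).0 is answered by the guarded receiver, whose match on the protected l0 fails *)
    inversion Ep; subst m y2.
    assert (P = Nil).
    { destruct (fresh_v [P] [x; x']) as [w [Hw1 Hw2]].
      specialize (Hsw w (Hw1 _ (or_introl eq_refl)) ltac:(simpl; auto)). simpl in Hsw.
      apply alpha_nil_r in Hsw. apply mapv_nil in Hsw. auto. }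
    subst P. destruct (trans_recv_match l0 k y q l) as [q' Htq].
    simpl. exists (Pre (PMatch (NC l) (NC l0) q') Nil), (Pre (PMatch (NC l) (NC l0) q') Nil), Nil.
    repeat split.
    * auto.
    * apply al_refl.
    * apply al_refl.
    * apply corr_failed_match. intro; subst. apply (proj2 (proj1 HC) k l0 eq_refl); auto.
Qed.

Lemma bw_match (a : name) (p : prefix) (P : proc) (al : act) (P' : proc) :
  bw_motive (Pre p P) al P' ->
  bw_motive (Pre (PMatch a a p) P) al P'.
Proof.
  intros IHHt B0 Hs L pk A0 HE Ha HC.
  destruct (alpha_peel _ _ _ _ _ (al_sym _ _ Ha)) as [q' [R' [-> Hq]]].
  apply corr_inv_pre_r in HE.
  destruct HE as [-> [[A' [-> HE]]|[m [y2 [l0 [y [q [Ep _]]]]]]]]; try discriminate.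
  assert (Hs': size (Pre q' R') <= S n) by (simpl in *; lia).
  assert (HC': bw_side L al (Pre q' A') (Pre q' R')).
  { destruct HC as [[HC1 HC2] HC3]. split; [split; [exact HC1|exact HC2]|].
    intros c Hc Hf. apply (HC3 c Hc). simpl in *. destruct Hf; auto. }
  destruct (IHHt (Pre q' R') Hs' L None (Pre q' A') (corr_pre _ _ _ _ HE) (al_sym _ _ Hq) HC')
    as [A's [A0s [B0s [Ht2 [Ha2 [Hb2 HE2]]]]]].
  simpl. exists A's, A0s, B0s. repeat split; auto. apply t_match; auto.
Qed.

Lemma bw_res (k : chan) (P : proc) (al : act) (P' : proc) :
  trans P al P' -> ~ act_names al k -> bw_motive (Res k P) al (Res k P').
Proof.
  intros Ht Hk B0 Hs L pk A0 HE Ha HC.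
  destruct (alpha_res _ _ _ (al_sym _ _ Ha)) as [k' [PB [-> Hsw]]].
  apply corr_inv_res_r in HE. destruct HE as [-> HE].
  destruct HE as [[A' [-> HE]]|[[A' [-> [HE Hfo]]]|[[A' [-> HE]]|[W ->]]]].
  4:{ exfalso. eapply self_output_stuck; [apply t_res; eauto|apply al_sym; exact Ha]. }
  all: destruct (res_fresh_body k P al P' k' PB L [A'] Ht Hk Hsw)
         as [z [HzL [HzA [HzP' [HzPB [Hza [Hsw' Ht']]]]]]].
  all: specialize (HzA A' (or_introl eq_refl)).
  all: assert (Hsz : size (mapc (swap k' z) PB) <= n) by (rewrite size_mapc; simpl in Hs; lia).
  all: simpl.
  -
    destruct (IHn _ Hsz (rem z L) None (mapc (swap k' z) A') (corr_res_rename L k' A' PB z HE HzL)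
      _ _ _ Hsw' Ht' (bw_side_res_rename L al k' z A' PB HC HzA HzPB Hza))
      as [A's [A0s [B0s [Ht2 [Ha2 [Hb2 HE2]]]]]].
    exists (Res z A's), (Res z A0s), (Res z B0s). repeat split.
    + apply trans_res_renamed; auto.
    + apply al_res; auto.
    + apply al_sym, alpha_res_renamed, al_sym; auto.
    + apply corr_res; auto.
  - (* protected restriction: z stays protected, as it is not extruded *)
    destruct (IHn _ Hsz (z :: rem z L) None (mapc (swap k' z) A') (corr_prot_rename L k' A' PB z HE HzL)
      _ _ _ Hsw' Ht' (bw_side_prot_rename L al k' z A' PB HC HzA HzPB Hfo Hza))
      as [A's [A0s [B0s [Ht2 [Ha2 [Hb2 HE2]]]]]].
    exists (Res z A's), (Res z A0s), (Res z B0s). repeat split.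
    + apply trans_res_renamed; auto.
    + apply al_res; auto.
    + apply al_sym, alpha_res_renamed, al_sym; auto.
    + apply corr_prot; auto. intro Hf. rewrite (alpha_fo _ _ _ Hb2) in Hf.
      destruct (trans_fo _ _ _ Ht' z Hf) as [Hf2|Hf2].
      * rewrite <- (alpha_fo _ _ _ Hsw'), fo_swap, swap_r in Hf2. auto.
      * apply Hza, act_bn_names; auto.
  - (* pending sender: the action cannot involve the private channel z *)
    pose proof (corr_mapc (swap k' z) _ _ _ _ (swap_inj k' z) HE) as HE'. simpl in HE'. rewrite swap_l in HE'.
    assert (HC' : bw_side [] al (mapc (swap k' z) A') (mapc (swap k' z) PB)).
    { split; [split; intros; simpl in *; tauto|]. apply bn_not_free_res_rename; auto. exact (proj2 HC). }
    destruct (IHn _ Hsz [] (Some z) (mapc (swap k' z) A') HE' _ _ _ Hsw' Ht' HC')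
      as [[d ->]|[[c0 ->]|[_ [A's [A0s [B0s [Ht2 [Ha2 [Hb2 HE2]]]]]]]]]; [simpl in Hza; tauto..|].
    exists (Res z A's), (Res z A0s), (Res z B0s). repeat split.
    + apply trans_res_renamed; auto.
    + apply al_res; auto.
    + apply al_sym, alpha_res_renamed, al_sym; auto.
    + apply corr_res. eapply corr_protected; eauto. simpl; tauto.
Qed.

Lemma bw_open (k l : chan) (P Q : proc) :
  trans P (AOut k l) Q -> k <> l -> bw_motive (Res l P) (ABOut k l) Q.
Proof.
  intros Ht Hkl B0 Hs L pk A0 HE Ha HC.
  destruct (alpha_res _ _ _ (al_sym _ _ Ha)) as [l' [PB [-> Hsw]]].
  apply corr_inv_res_r in HE. destruct HE as [-> HE].
  destruct HE as [[A' [-> HE]]|[[A' [-> [HE Hfo]]]|[[A' [-> HE]]|[W ->]]]].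
  4:{ exfalso. eapply self_output_stuck; [apply t_open; eauto|apply al_sym; exact Ha]. }
  all: destruct (open_fresh_body k l P Q l' PB L [A'] Ht Hkl Hsw)
         as [z [Hz [HzA [HzQ [HzPB [Hsw' Ht']]]]]].
  all: specialize (HzA A' (or_introl eq_refl)); simpl in Hz.
  all: assert (Hsz : size (mapc (swap l' z) PB) <= n) by (rewrite size_mapc; simpl in Hs; lia).
  all: assert (Hfl : ~ free_chan l (Res l' A')) by (apply (proj2 HC); simpl; auto).
  -
    assert (HE1 : Corr (rem l' (rem l L)) None A' PB).
    { eapply corr_protected; eauto. intros c Hc Hf. rewrite !in_rem in *. destruct Hc as [Hc Hc'].
      destruct (Nat.eq_dec c l); [subst|tauto]. exfalso. apply Hfl. simpl; split; auto. }
    assert (HC' : bw_side (rem z (rem l L)) (AOut k z) (mapc (swap l' z) A') (mapc (swap l' z) PB)).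
    { destruct (fw_side_res_rename L _ l' z PB (proj1 HC) HzPB) as [HL _].
      split; [split|intros c Hc; simpl in Hc; tauto].
      - intros l0 Hl0. apply HL. rewrite !in_rem in *. tauto.
      - discriminate. }
    assert (Hzl : ~ In z (rem l L)) by (rewrite in_rem; tauto).
    destruct (IHn _ Hsz (rem z (rem l L)) None (mapc (swap l' z) A') (corr_res_rename (rem l L) l'
        A' PB z HE1 Hzl)
      _ _ _ Hsw' Ht' HC') as [A's [A0s [B0s [Ht2 [Ha2 [Hb2 HE2]]]]]].
    simpl. exists (mapc (swap z l) A's), (mapc (swap z l) A0s), (mapc (swap z l) B0s). repeat split.
    + apply trans_open_renamed; auto; intro; subst; tauto.
    + apply alpha_swap; auto.
    + apply (alpha_swap z l) in Hb2. rewrite (mapc_swap_sym l z Q), swap_mapc_inv in Hb2. exact Hb2.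
    + pose proof (corr_mapc (swap z l) _ _ _ _ (swap_inj z l) HE2) as HE3. simpl in HE3.
      eapply corr_protected; eauto. intros c Hc Hf. apply in_map_iff in Hc. destruct Hc as [c0 [<- Hc]].
      rewrite !in_rem in Hc. rewrite swap_o by tauto. tauto.
  - (* protected restriction: impossible, the extruded channel would be an output object *)
    exfalso. pose proof (trans_out_fo _ _ _ Ht' k z eq_refl) as Hf.
    rewrite <- (alpha_fo _ _ _ Hsw'), fo_swap, swap_r in Hf. auto.
  - (* pending sender: a free output on its private channel is impossible *)
    pose proof (corr_mapc (swap l' z) _ _ _ _ (swap_inj l' z) HE) as HE'. simpl in HE'. rewrite swap_l in HE'.
    assert (HC' : bw_side [] (AOut k z) (mapc (swap l' z) A') (mapc (swap l' z) PB))
      by (split; [split|]; intros; simpl in *; auto; discriminate).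
    destruct (IHn _ Hsz [] (Some z) (mapc (swap l' z) A') HE' _ _ _ Hsw' Ht' HC')
      as [[d Ed]|[[c0 Ec]|[Et _]]]; discriminate.
Qed.

Lemma bw_parl (P Q R : proc) (al : act) :
  trans P al Q ->
  bw_motive P al Q ->
  bw_motive (Par P R) al (Par Q R).
Proof.
  intros Ht IHHt B0 Hs L pk A0 HE Ha HC.
  destruct (alpha_par_r _ _ _ Ha) as [PB [RB [-> [HP HR]]]].
  apply corr_inv_par_r in HE.
  destruct HE as [[-> [A1 [A2 [-> [HE1 HE2]]]]]|[k [l [mm [y [q [A2 [-> [-> [-> [-> [Hm [Hkl [HE2
      HI]]]]]]]]]]]]]].
  + assert (Hs1: size PB <= S n) by (simpl in Hs; lia).
    assert (HC1: bw_side L al A1 PB).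
    { destruct HC as [[HC1 HC2] HC3]; split; [split|]; auto.
      - intros l0 Hl0 Hf; apply (HC1 l0 Hl0); simpl; auto.
      - intros c Hc Hf; apply (HC3 c Hc); simpl; auto. }
    destruct (IHHt PB Hs1 L None A1 HE1 HP HC1) as [A's [A0s [B0s [Ht2 [Ha2 [Hb2 HE3]]]]]].
    simpl. exists (Par A's A2), (Par A0s A2), (Par B0s RB). repeat split.
    * apply t_parl; auto. intros c Hc Hf. apply (proj2 HC c Hc). simpl; auto.
    * apply al_par; auto; apply al_refl.
    * apply al_par; auto.
    * apply corr_par; auto.
  + simpl. left. destruct (sender_nil_trans_inv _ _ _ Ht l k mm y (al_sym _ _ HP) Hkl Hm) as [d [Ed
      _]]. eauto.
Qed.

Lemma bw_parr (P Q R : proc) (al : act) :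
  trans P al Q ->
  bw_motive P al Q ->
  bw_motive (Par R P) al (Par R Q).
Proof.
  intros Ht IHHt B0 Hs L pk A0 HE Ha HC.
  destruct (alpha_par_r _ _ _ Ha) as [RB [PB [-> [HR HP]]]].
  apply corr_inv_par_r in HE.
  destruct HE as [[-> [A1 [A2 [-> [HE1 HE2]]]]]|[k [l [mm [y [q [A2 [-> [-> [-> [-> [Hm [Hkl [HE2
      HI]]]]]]]]]]]]]].
  + assert (Hs1: size PB <= S n) by (simpl in Hs; lia).
    assert (HC1: bw_side L al A2 PB).
    { destruct HC as [[HC1 HC2] HC3]; split; [split|]; auto.
      - intros l0 Hl0 Hf; apply (HC1 l0 Hl0); simpl; auto.
      - intros c Hc Hf; apply (HC3 c Hc); simpl; auto. }
    destruct (IHHt PB Hs1 L None A2 HE2 HP HC1) as [A's [A0s [B0s [Ht2 [Ha2 [Hb2 HE3]]]]]].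
    simpl. exists (Par A1 A's), (Par A1 A0s), (Par RB B0s). repeat split.
    * apply t_parr; auto. intros c Hc Hf. apply (proj2 HC c Hc). simpl; auto.
    * apply al_par; auto; apply al_refl.
    * apply al_par; auto.
    * apply corr_par; auto.
  + simpl. right; left. apply (corr_input_form _ _ _ k HE2) in HI. destruct HI as [x [W ->]].
    exact (inp_inv _ _ _ Ht k x W (al_sym _ _ HP)).
Qed.

Lemma bw_comml (P P' Q Q' : proc) (k l : chan) :
  trans P (AOut k l) P' ->
  bw_motive P (AOut k l) P' ->
  bw_motive Q (AIn k l) Q' ->
  bw_motive (Par P Q) ATau (Par P' Q').
Proof.
  intros Ht1 IHHt1 IHHt2 B0 Hs L pk A0 HE Ha HC.
  destruct (alpha_par_r _ _ _ Ha) as [PB [QB [-> [HP HQ]]]].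
  apply corr_inv_par_r in HE.
  destruct HE as [[-> [A1 [A2 [-> [HE1 HE2]]]]]|[k0 [l0 [mm [y [q [A2 [-> [-> [-> [-> [Hm [Hkl [HE2
      HI]]]]]]]]]]]]]].
  + assert (Hs1: size PB <= S n) by (simpl in Hs; lia).
    assert (Hs2: size QB <= S n) by (simpl in Hs; lia).
    assert (HC1: bw_side L (AOut k l) A1 PB).
    { destruct HC as [[HC1 HC2] HC3]; split; [split|]; try (intros; discriminate); try (intros;
        simpl in *; tauto).
      intros l1 Hl1 Hf; apply (HC1 l1 Hl1); simpl; auto. }
    destruct (IHHt1 PB Hs1 L None A1 HE1 HP HC1) as [A'p [A0p [B0p [Htp [Hap [Hbp HEp]]]]]].
    assert (Hl: ~ In l L).
    { intro Hl. apply (proj1 (proj1 HC) l Hl). simpl; left. rewrite (alpha_fo _ _ _ HP).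
        eapply trans_out_fo; eauto. }
    assert (HC2: bw_side L (AIn k l) A2 QB).
    { destruct HC as [[HC1' HC2'] HC3']; split; [split|]; try (intros; simpl in *; tauto).
      - intros l1 Hl1 Hf; apply (HC1' l1 Hl1); simpl; auto.
      - intros k1 c1 Ea; inversion Ea; subst; auto. }
    destruct (IHHt2 QB Hs2 L None A2 HE2 HQ HC2) as [A'q [A0q [B0q [Htq [Haq [Hbq HEq]]]]]].
    simpl. exists (Par A'p A'q), (Par A0p A0q), (Par B0p B0q). repeat split.
    * eapply t_comml; eauto.
    * apply al_par; auto.
    * apply al_par; auto.
    * apply corr_par; auto.
  + exfalso. destruct (sender_nil_trans_inv _ _ _ Ht1 l0 k0 mm y (al_sym _ _ HP) Hkl Hm) as [d [Ed
      _]]. discriminate.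
Qed.

Lemma bw_commr (P P' Q Q' : proc) (k l : chan) :
  trans P (AIn k l) P' ->
  bw_motive P (AIn k l) P' ->
  trans Q (AOut k l) Q' ->
  bw_motive Q (AOut k l) Q' ->
  bw_motive (Par P Q) ATau (Par P' Q').
Proof.
  intros Ht1 IHHt1 Ht2 IHHt2 B0 Hs L pk A0 HE Ha HC.
  destruct (alpha_par_r _ _ _ Ha) as [PB [QB [-> [HP HQ]]]].
  apply corr_inv_par_r in HE.
  destruct HE as [[-> [A1 [A2 [-> [HE1 HE2]]]]]|[k0 [l0 [mm [y [q [A2 [-> [-> [-> [-> [Hm [Hkl [HE2
      HI]]]]]]]]]]]]]].
  + assert (Hs1: size PB <= S n) by (simpl in Hs; lia).
    assert (Hs2: size QB <= S n) by (simpl in Hs; lia).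
    assert (HC2: bw_side L (AOut k l) A2 QB).
    { destruct HC as [[HC1 HC2] HC3]; split; [split|]; try (intros; discriminate); try (intros;
        simpl in *; tauto).
      intros l1 Hl1 Hf; apply (HC1 l1 Hl1); simpl; auto. }
    destruct (IHHt2 QB Hs2 L None A2 HE2 HQ HC2) as [A'q [A0q [B0q [Htq [Haq [Hbq HEq]]]]]].
    assert (Hl: ~ In l L).
    { intro Hl. apply (proj1 (proj1 HC) l Hl). simpl; right. rewrite (alpha_fo _ _ _ HQ).
        eapply trans_out_fo; eauto. }
    assert (HC1: bw_side L (AIn k l) A1 PB).
    { destruct HC as [[HC1' HC2'] HC3']; split; [split|]; try (intros; simpl in *; tauto).
      - intros l1 Hl1 Hf; apply (HC1' l1 Hl1); simpl; auto.
      - intros k1 c1 Ea; inversion Ea; subst; auto. }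
    destruct (IHHt1 PB Hs1 L None A1 HE1 HP HC1) as [A'p [A0p [B0p [Htp [Hap [Hbp HEp]]]]]].
    simpl. exists (Par A'p A'q), (Par A0p A0q), (Par B0p B0q). repeat split.
    * eapply t_commr; eauto.
    * apply al_par; auto.
    * apply al_par; auto.
    * apply corr_par; auto.
  + exfalso. destruct (sender_nil_trans_inv _ _ _ Ht1 l0 k0 mm y (al_sym _ _ HP) Hkl Hm) as [d [Ed
      _]]. discriminate.
Qed.

(* The key step, backwards: the match-free sender extrudes l to its partner; the sender
   with the match answers after renaming its bound channel to the fresh z, and z is
   protected from then on. *)
Lemma bw_close_sender P P' Q Q' k l k0 l0 mm y q A2 QB :
  trans P (ABOut k l) P' -> trans Q (AIn k l) Q' -> ~ free_chan l Q ->
  alpha (sender_nil l0 (Some k0) mm y) P -> alpha QB Q -> size QB <= n ->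
  mm <> Some l0 -> k0 <> l0 -> Corr [] None A2 QB ->
  bw_result (Some k0) [] ATau (Par (sender l0 (Some k0) mm y q) A2) (Res l (Par P' Q')).
Proof.
  intros Ht1 Ht2 H HP HQ Hs2 Hm Hkl HE2.
  destruct (sender_nil_trans_inv _ _ _ Ht1 l0 k0 mm y (al_sym _ _ HP) Hkl Hm) as [d [Ed [Hkd [Hmd Hq']]]].
  inversion Ed; subst k0 d.
  destruct (fresh_c [A2; QB; Q; Q'; P'; Pre (POut (NC k) l0) (recv_match l0 (odflt l0 mm) y q)]
                    [k; l; l0; odflt l0 mm]) as [z [Hz1 Hz2]]. simpl in Hz2.
  assert (HzA : ~ occurs_c z A2) by (apply Hz1; simpl; auto).
  assert (HzQ : ~ occurs_c z Q) by (apply Hz1; simpl; auto 10).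
  assert (HzP' : ~ occurs_c z P') by (apply Hz1; simpl; auto 10).
  assert (HzQ' : ~ occurs_c z Q') by (apply Hz1; simpl; auto 10).
  assert (HzS : ~ occurs_c z (Pre (POut (NC k) l0) (recv_match l0 (odflt l0 mm) y q)))
    by (apply Hz1; simpl; auto 10).
  pose proof (trans_swap l z _ _ _ Ht2) as Ht2'. simpl in Ht2'.
  rewrite swap_l, (swap_o l z k) in Ht2' by (auto; intro; subst; tauto).
  assert (HQ' : alpha QB (mapc (swap l z) Q)).
  { eapply al_trans; eauto. apply alpha_swap_nonfree; auto. intro Hf; apply HzQ, free_occ; auto. }
  assert (HC2 : bw_side [] (AIn k z) A2 QB) by (split; [split|]; intros; simpl in *; auto; discriminate).
  destruct (IHn QB Hs2 [] None A2 HE2 _ _ _ HQ' Ht2' HC2) as [A'q [A0q [B0q [Htq [Haq [Hbq HEq]]]]]].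
  simpl. right; right. split; auto.
  exists (Res z (Par (recv_match z (odflt z mm) y (mapc_pref (swap l0 z) q)) A'q)),
         (Res z (Par (recv_match z (odflt z mm) y (mapc_pref (swap l0 z) q)) A0q)),
         (Res z (Par (recv_nil (odflt z mm) y) B0q)). repeat split.
  - eapply t_closel; [|exact Htq|intro Hf; apply HzA, free_occ; auto].
    eapply t_alpha; [apply (sender_rename l0 (Some k) mm y q z); try congruence; auto|].
    + intro E'; inversion E'; subst; tauto.
    + intro E'; subst; simpl in Hz2; tauto.
    + apply sender_open. intro; subst; tauto.
  - apply al_res, al_par; [apply al_refl|auto].
  - eapply al_trans; [|apply al_sym, (alpha_res_swap l z (Par P' Q')); simpl; tauto].
    apply al_res. simpl. apply al_par; auto.
    apply (alpha_swap l z) in Hq'. rewrite mapc_recv_nil in Hq'.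
    rewrite swap_odflt in Hq' by (auto; intro; subst; simpl in Hz2; tauto). apply al_sym; auto.
  - apply corr_prot.
    + simpl. apply corr_par; [apply corr_recv; simpl; auto|]. eapply corr_protected; eauto. simpl; tauto.
    + intro Hf. simpl in Hf. destruct Hf as [Hf|Hf]; [unfold recv_nil in Hf; simpl in Hf; tauto|].
      rewrite (alpha_fo _ _ _ Hbq), fo_swap, swap_r in Hf.
      destruct (trans_fo _ _ _ Ht2 l Hf) as [Hf2|Hf2]; [|simpl in Hf2; tauto].
      apply fo_free in Hf2. auto.
Qed.

Lemma bw_closel (P P' Q Q' : proc) (k l : chan) :
  trans P (ABOut k l) P' ->
  trans Q (AIn k l) Q' ->
  ~ free_chan l Q ->
  bw_motive (Par P Q) ATau (Res l (Par P' Q')).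
Proof.
  intros Ht1 Ht2 H B0 Hs L pk A0 HE Ha HC.
  destruct (alpha_par_r _ _ _ Ha) as [PB [QB [-> [HP HQ]]]].
  apply corr_inv_par_r in HE.
  destruct HE as [[-> [A1 [A2 [-> [HE1 HE2]]]]]|[k0 [l0 [mm [y [q [A2 [-> [-> [-> [-> [Hm [Hkl [HE2
      HI]]]]]]]]]]]]]];
    [|apply (bw_close_sender P P' Q Q' k l k0 l0 mm y q A2 QB); auto; simpl in Hs; lia].
  assert (Hs1 : size PB <= n) by (simpl in Hs; lia).
  assert (Hs2 : size QB <= n) by (simpl in Hs; lia).
  destruct (extrusion_fresh k l P P' Q Q' PB QB [A1; A2; P'; Q'] L Ht1 Ht2 H HP HQ)
    as [z [Hz [HzR [HP' [HQ' [Ht1' Ht2']]]]]].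
  simpl in Hz.
  assert (HzA1 : ~ occurs_c z A1) by (apply HzR; simpl; auto).
  assert (HzA2 : ~ occurs_c z A2) by (apply HzR; simpl; auto).
  assert (HzP' : ~ occurs_c z P') by (apply HzR; simpl; auto).
  assert (HzQ' : ~ occurs_c z Q') by (apply HzR; simpl; auto).
  destruct (bw_side_extrude L k z A1 PB (Par PB QB) (proj1 HC)) as [HC1 _]; [simpl; auto|tauto|auto|].
  destruct (bw_side_extrude L k z A2 QB (Par PB QB) (proj1 HC)) as [_ HC2]; [simpl; auto|tauto|auto|].
  destruct (IHn PB Hs1 L None A1 HE1 _ _ _ HP' Ht1' HC1) as [A'p [A0p [B0p [Htp [Hap [Hbp HEp]]]]]].
  destruct (IHn QB Hs2 L None A2 HE2 _ _ _ HQ' Ht2' HC2) as [A'q [A0q [B0q [Htq [Haq [Hbq HEq]]]]]].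
  simpl. exists (Res z (Par A'p A'q)), (Res z (Par A0p A0q)), (Res z (Par B0p B0q)). repeat split.
  - eapply t_closel; eauto. intro Hf; apply HzA2, free_occ; auto.
  - apply al_res, al_par; auto.
  - eapply al_trans; [apply al_res, al_par; [exact Hbp|exact Hbq]|].
    apply al_sym, (alpha_res_swap l z (Par P' Q')). simpl; tauto.
  - apply corr_res, corr_rem_fresh; [tauto|apply corr_par; auto].
Qed.

Lemma bw_closer (P P' Q Q' : proc) (k l : chan) :
  trans P (AIn k l) P' ->
  trans Q (ABOut k l) Q' ->
  ~ free_chan l P ->
  bw_motive (Par P Q) ATau (Res l (Par P' Q')).
Proof.
  intros Ht1 Ht2 H B0 Hs L pk A0 HE Ha HC.
  destruct (alpha_par_r _ _ _ Ha) as [PB [QB [-> [HP HQ]]]].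
  apply corr_inv_par_r in HE.
  destruct HE as [[-> [A1 [A2 [-> [HE1 HE2]]]]]|[k0 [l0 [mm [y [q [A2 [-> [-> [-> [-> [Hm [Hkl [HE2
      HI]]]]]]]]]]]]]].
  2:{ (* the pending sender cannot perform an input *)
    exfalso. destruct (sender_nil_trans_inv _ _ _ Ht1 l0 k0 mm y (al_sym _ _ HP) Hkl Hm) as [d [Ed _]].
    discriminate. }
  assert (Hs1 : size PB <= n) by (simpl in Hs; lia).
  assert (Hs2 : size QB <= n) by (simpl in Hs; lia).
  destruct (extrusion_fresh k l Q Q' P P' QB PB [A1; A2; P'; Q'] L Ht2 Ht1 H HQ HP)
    as [z [Hz [HzR [HQ' [HP' [Ht2' Ht1']]]]]].
  simpl in Hz.
  assert (HzA1 : ~ occurs_c z A1) by (apply HzR; simpl; auto).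
  assert (HzA2 : ~ occurs_c z A2) by (apply HzR; simpl; auto).
  assert (HzP' : ~ occurs_c z P') by (apply HzR; simpl; auto).
  assert (HzQ' : ~ occurs_c z Q') by (apply HzR; simpl; auto).
  destruct (bw_side_extrude L k z A1 PB (Par PB QB) (proj1 HC)) as [_ HC1]; [simpl; auto|tauto|auto|].
  destruct (bw_side_extrude L k z A2 QB (Par PB QB) (proj1 HC)) as [HC2 _]; [simpl; auto|tauto|auto|].
  destruct (IHn PB Hs1 L None A1 HE1 _ _ _ HP' Ht1' HC1) as [A'p [A0p [B0p [Htp [Hap [Hbp HEp]]]]]].
  destruct (IHn QB Hs2 L None A2 HE2 _ _ _ HQ' Ht2' HC2) as [A'q [A0q [B0q [Htq [Haq [Hbq HEq]]]]]].
  simpl. exists (Res z (Par A'p A'q)), (Res z (Par A0p A0q)), (Res z (Par B0p B0q)). repeat split.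
  - eapply t_closer; eauto. intro Hf; apply HzA1, free_occ; auto.
  - apply al_res, al_par; auto.
  - eapply al_trans; [apply al_res, al_par; [exact Hbp|exact Hbq]|].
    apply al_sym, (alpha_res_swap l z (Par P' Q')). simpl; tauto.
  - apply corr_res, corr_rem_fresh; [tauto|apply corr_par; auto].
Qed.

Lemma bw_rep_act (P P' : proc) (al : act) :
  bw_motive P al P' ->
  bw_motive (Rep P) al (Par P' (Rep P)).
Proof.
  intros IHHt B0 Hs L pk A0 HE Ha HC.
  destruct (alpha_rep_r _ _ Ha) as [PB [-> HP]].
  apply corr_inv_rep_r in HE. destruct HE as [-> [A' [-> HE]]].
  assert (Hs1: size PB <= S n) by (simpl in Hs; lia).
  destruct (IHHt PB Hs1 L None A' HE HP HC) as [A's [A0s [B0s [Ht2 [Ha2 [Hb2 HE3]]]]]].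
  simpl. exists (Par A's (Rep A')), (Par A0s (Rep A')), (Par B0s (Rep PB)). repeat split.
  * apply t_rep_act; auto.
  * apply al_par; auto; apply al_refl.
  * apply al_par; auto; apply al_rep; auto.
  * apply corr_par; auto; apply corr_rep; auto.
Qed.

Lemma bw_rep_comm (P P' P'' : proc) (k l : chan) :
  trans P (AOut k l) P' ->
  bw_motive P (AOut k l) P' ->
  bw_motive P (AIn k l) P'' ->
  bw_motive (Rep P) ATau (Par (Par P' P'') (Rep P)).
Proof.
  intros Ht1 IHHt1 IHHt2 B0 Hs L pk A0 HE Ha HC.
  destruct (alpha_rep_r _ _ Ha) as [PB [-> HP]].
  apply corr_inv_rep_r in HE. destruct HE as [-> [A' [-> HE]]].
  assert (Hs1: size PB <= S n) by (simpl in Hs; lia).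
  assert (HC1: bw_side L (AOut k l) A' PB).
  { destruct HC as [[HC1 HC2] HC3]; split; [split; [exact HC1|]|]; intros; [discriminate|simpl in *; tauto]. }
  destruct (IHHt1 PB Hs1 L None A' HE HP HC1) as [A'a [A0a [B0a [Hta [Haa [Hba HEa]]]]]].
  assert (Hl: ~ In l L).
  { intro Hl. apply (proj1 (proj1 HC) l Hl). simpl. rewrite (alpha_fo _ _ _ HP).
      exact (trans_out_fo _ _ _ Ht1 k l eq_refl). }
  assert (HC2: bw_side L (AIn k l) A' PB).
  { destruct HC as [[HC1' HC2'] HC3']; split; [split; [exact HC1'|]|]; [|intros; simpl in *; tauto].
    intros k1 c1 Ea; inversion Ea; subst; auto. }
  destruct (IHHt2 PB Hs1 L None A' HE HP HC2) as [A'b [A0b [B0b [Htb [Hab [Hbb HEb]]]]]].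
  simpl. exists (Par (Par A'a A'b) (Rep A')), (Par (Par A0a A0b) (Rep A')),
      (Par (Par B0a B0b) (Rep PB)). repeat split.
  * eapply t_rep_comm; eauto.
  * apply al_par; [apply al_par; auto|apply al_refl].
  * apply al_par; [apply al_par; auto|apply al_rep; auto].
  * apply corr_par; [apply corr_par; auto|apply corr_rep; auto].
Qed.

Lemma bw_rep_close (P P' P'' : proc) (k l : chan) :
  trans P (ABOut k l) P' ->
  trans P (AIn k l) P'' ->
  ~ free_chan l P ->
  bw_motive (Rep P) ATau (Par (Res l (Par P' P'')) (Rep P)).
Proof.
  intros Ht1 Ht2 H B0 Hs L pk A0 HE Ha HC.
  destruct (alpha_rep_r _ _ Ha) as [PB [-> HP]].
  apply corr_inv_rep_r in HE. destruct HE as [-> [A' [-> HE]]].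
  assert (Hs1 : size PB <= n) by (simpl in Hs; lia).
  destruct (extrusion_fresh k l P P' P P'' PB PB [A'; P'; P''] L Ht1 Ht2 H HP HP)
    as [z [Hz [HzR [HP' [_ [Ht1' Ht2']]]]]].
  simpl in Hz.
  assert (HzA : ~ occurs_c z A') by (apply HzR; simpl; auto).
  assert (HzP' : ~ occurs_c z P') by (apply HzR; simpl; auto).
  assert (HzP'' : ~ occurs_c z P'') by (apply HzR; simpl; auto).
  destruct (bw_side_extrude L k z A' PB (Rep PB) (proj1 HC)) as [HC1 HC2]; [simpl; auto|tauto|auto|].
  destruct (IHn PB Hs1 L None A' HE _ _ _ HP' Ht1' HC1) as [A'a [A0a [B0a [Hta [Haa [Hba HEa]]]]]].
  destruct (IHn PB Hs1 L None A' HE _ _ _ HP' Ht2' HC2) as [A'b [A0b [B0b [Htb [Hab [Hbb HEb]]]]]].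
  simpl. exists (Par (Res z (Par A'a A'b)) (Rep A')), (Par (Res z (Par A0a A0b)) (Rep A')),
    (Par (Res z (Par B0a B0b)) (Rep PB)). repeat split.
  - eapply t_rep_close; eauto. intro Hf; apply HzA, free_occ; auto.
  - apply al_par; [apply al_res, al_par; auto|apply al_refl].
  - apply al_par; [|apply al_rep; auto].
    eapply al_trans; [apply al_res, al_par; [exact Hba|exact Hbb]|].
    apply al_sym, (alpha_res_swap l z (Par P' P'')). simpl; tauto.
  - apply corr_par; [|apply corr_rep; auto]. apply corr_res, corr_rem_fresh; [tauto|apply corr_par; auto].
Qed.

Lemma bw_alpha (P P' : proc) (al : act) (Q : proc) :
  alpha P P' ->
  bw_motive P' al Q ->
  bw_motive P al Q.
Proof.
  intros H IHHt B0 Hs L pk A0 HE Ha HC.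
  eapply IHHt; eauto. eapply al_trans; eauto.
Qed.

Lemma bw_step B1 a B' : trans B1 a B' -> bw_motive B1 a B'.
Proof.
  induction 1; eauto using bw_out, bw_in, bw_match, bw_res, bw_open, bw_parl, bw_parr, bw_comml,
    bw_commr, bw_closel, bw_closer, bw_rep_act, bw_rep_comm, bw_rep_close, bw_alpha.
Qed.
End Backward.

Lemma backward_sim n : backward_claim n.
Proof.
  induction n as [|n IHn]; intros B Hs L pk A HE B1 a B' Ha Ht HC.
  - pose proof (size_pos B); lia.
  - eapply bw_step; eauto.
Qed.

Definition corr_upto_alpha (A B : proc) : Prop := exists A0 B0,
    alpha A0 A /\ alpha B0 B /\ Corr [] None A0 B0.

Definition corr_sym (A B : proc) : Prop := corr_upto_alpha A B \/ corr_upto_alpha B A.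

Lemma corr_sym_is_bisim : is_bisim corr_sym.
Proof. split.
  - intros P Q [H|H]; [right|left]; auto.
  - intros P Q [[A0 [B0 [HA [HB HE]]]]|[A0 [B0 [HA [HB HE]]]]] al P' Ht Hbn.
    + assert (HC: fw_side [] al B0) by (split; intros; simpl in *; tauto).
      pose proof (forward_sim (size A0) A0 (le_n _) [] None B0 HE P al P' HA Ht HC) as Hc.
      simpl in Hc. destruct Hc as [A1 [B' [B1 [Ht2 [Ha2 [Hb2 HE2]]]]]].
      exists B'. split.
      * eapply t_alpha; [apply al_sym; exact HB|exact Ht2].
      * left. exists A1, B1. repeat split; auto; try apply al_refl; apply al_sym; auto.
    + assert (HC: bw_side [] al A0 B0).
      { split; [split|]; intros; simpl in *; try tauto.
        intro Hf. rewrite (alpha_free _ _ _ HA) in Hf. apply (Hbn c); auto. }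
      pose proof (backward_sim (size B0) B0 (le_n _) [] None A0 HE P al P' HB Ht HC) as Hc.
      simpl in Hc. destruct Hc as [A' [A1 [B1 [Ht2 [Ha2 [Hb2 HE2]]]]]].
      exists A'. split.
      * eapply t_alpha; [apply al_sym; exact HA|exact Ht2].
      * right. exists A1, B1. repeat split; auto; apply al_sym; auto.
Qed.

(* The two processes of the theorem are related: when k = l the sender is dead (it
   outputs on its own bound name); otherwise they form the pending-sender configuration.
   The receiving channel m is encoded relatively to the binder l. *)
Lemma theorem_pair_corr (P : proc) (m : chan) (pi : prefix) (k l : chan) (x y : var) :
  Corr [] None
    (Res k (Par (Res l (Pre (POut (NC k) l) (Pre (PIn (NC m) y) (Pre (PMatch (NV y) (NC l) pi) Nil))))
                (Pre (PIn (NC k) x) P)))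
    (Res k (Par (Res l (Pre (POut (NC k) l) (Pre (PIn (NC m) y) Nil)))
                (Pre (PIn (NC k) x) P))).
Proof.
  set (mm := if Nat.eqb m l then None else Some m).
  assert (Hmm : mm <> Some l) by (unfold mm; destruct (Nat.eqb_spec m l); congruence).
  assert (Hm : odflt l mm = m) by (unfold mm; destruct (Nat.eqb_spec m l); simpl; auto).
  destruct (Nat.eq_dec k l) as [<-|Hkl].
  - apply corr_res. simpl. apply corr_par; [|apply corr_refl].
    pose proof (corr_dead_sender [] k mm y pi Hmm) as HD.
    unfold sender, sender_nil, recv_match, recv_nil in HD. simpl in HD. rewrite Hm in HD. exact HD.
  - apply corr_sender_res.
    pose proof (corr_sender_par k l mm y pi (Pre (PIn (NC k) x) P) (Pre (PIn (NC k) x) P) Hmm Hkl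
      (corr_refl _ _) ltac:(exists x, P; auto)) as HD.
    unfold sender, sender_nil, recv_match, recv_nil in HD. simpl in HD. rewrite Hm in HD. exact HD.
Qed.

Theorem proposition1 (P : proc) (m : chan) (pi : prefix) (k l : chan) (x y : var) :
  bisim
    (Res k (Par (Res l (Pre (POut (NC k) l)
                          (Pre (PIn (NC m) y)
                               (Pre (PMatch (NV y) (NC l) pi) Nil))))
                (Pre (PIn (NC k) x) P)))
    (Res k (Par (Res l (Pre (POut (NC k) l)
                          (Pre (PIn (NC m) y) Nil)))
                (Pre (PIn (NC k) x) P))).
Proof.
  exists corr_sym. split; [exact corr_sym_is_bisim|].
  left. do 2 eexists. split; [apply al_refl|]. split; [apply al_refl|].
  apply theorem_pair_corr.
Qed.
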